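(* Let $G$ be a finite simple robust graph, and let $uv \in E(G)$ with $d(u) \in \{7,8\}$ and $d(v) = 5$. If neither $\{u\}$ nor $\{v\}$ is reducible in $G$ and $u$ subsumes $v$, then $\{u,v\}$ is reducible in $G$.
   Context: $N[x] = N(x)\cup\{x\}$. For distinct vertices $u,v$, $u$ subsumes $v$ if $N[u] \supseteq N[v]$. $G$ is robust if for every $x\in V(G)$, every component of $G[N(x)]$ has at least $5$ vertices. For a set $\mathcal{S}$ of triangles, an $\mathcal{S}$-edge is an edge of a triangle in $\mathcal{S}$. A nonempty set $V_0 \subseteq V(G)$ is reducible if there exist a set $\mathcal{S}$ of pairwise edge-disjoint triangles of $G$ and a set $X \subseteq E(G)$ such that (i) $|X| \leq 2|\mathcal{S}|$; (ii) $G - X$ has no triangle containing a vertex of $V_0$; (iii) $X$ contains every $\mathcal{S}$-edge whose endpoints both lie outside $V_0$. *)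

From mathcomp Require Import all_boot.
Set Implicit Arguments. Unset Strict Implicit. Unset Printing Implicit Defensive.

Section Graph.
Variable T : finType.
Variable e : rel T.

Definition simple_graph := symmetric e /\ irreflexive e.

Definition nbhd (x : T) : {set T} := [set y | e x y].
Definition cnbhd (x : T) : {set T} := x |: nbhd x.
Definition deg (x : T) : nat := #|nbhd x|.

Definition subsumes (u v : T) : Prop := u != v /\ cnbhd v \subset cnbhd u.

Definition induced_rel (A : {set T}) : rel T :=
  fun a b => [&& e a b, a \in A & b \in A].

Definition component (A : {set T}) (y : T) : {set T} :=
  [set z in A | connect (induced_rel A) y z].

Definition robust : Prop :=
  forall x y, y \in nbhd x -> 5 <= #|component (nbhd x) y|.

Definition is_edge (f : {set T}) : bool :=
  [exists a, exists b, [&& e a b & f == [set a; b]]].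

Definition is_triangle (t : {set T}) : bool :=
  (#|t| == 3) && [forall a in t, forall b in t, (a != b) ==> e a b].

Definition edge_of (f t : {set T}) : bool := (f \subset t) && (#|f| == 2).

Definition edge_disjoint_triangles (S : {set {set T}}) : Prop :=
  (forall t, t \in S -> is_triangle t) /\
  (forall t1 t2, t1 \in S -> t2 \in S -> t1 != t2 -> #|t1 :&: t2| <= 1).

Definition reducible (V0 : {set T}) : Prop :=
  V0 != set0 /\
  exists (S : {set {set T}}) (X : {set {set T}}),
    edge_disjoint_triangles S /\
    (forall f, f \in X -> is_edge f) /\
    #|X| <= 2 * #|S| /\
    (* (ii) G - X has no triangle containing a vertex of V0 *)
    (forall t, is_triangle t -> t :&: V0 != set0 ->
       exists f, edge_of f t /\ f \in X) /\
    (forall t f, t \in S -> edge_of f t -> f :&: V0 = set0 -> f \in X).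

End Graph.

From mathcomp Require Import all_boot zify.
Set Implicit Arguments. Unset Strict Implicit. Unset Printing Implicit Defensive.

(* Since N[v] is contained in N[u], every triangle through u or v lies in the
   graph H induced by N[u]: u is adjacent to everything, v to u and to the four
   vertices of A = N(v) - u, and to none of the deg(u) - 5 = 2 or 3 vertices of
   B = N(u) - N[v].  A reducibility witness (S, X) for {u, v} or for {v} can
   therefore be read off H alone, as a finite "template" on the vertices of H,
   and any such template lifts to G.  Templates for {v} exist unless G[A] is a
   K4 or a K4 minus an edge, so the non-reducibility of {v} forces one of these
   two shapes; in both, every graph H (up to reordering A and B) has a template
   for {u, v}.  Both statements are finite and are checked by computation. *)

Definition triple := (nat * nat * nat)%type.
Definition template := (seq triple * seq (nat * nat))%type.

Definition triple_verts (t : triple) : seq nat := [:: t.1.1; t.1.2; t.2].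
Definition has_pair (X : seq (nat * nat)) (i j : nat) := ((i, j) \in X) || ((j, i) \in X).
Definition share_edge (t1 t2 : triple) :=
  has (fun i => has (fun j => [&& i != j, i \in triple_verts t2 & j \in triple_verts t2])
    (triple_verts t1)) (triple_verts t1).

Definition template_ok (V0 : seq nat) (c : template) :=
  [&& uniq c.1,
      all (fun t1 => all (fun t2 => (t1 == t2) || ~~ share_edge t1 t2) c.1) c.1 &
      all (fun t => all (fun i => all (fun j =>
        [|| i == j, i \in V0, j \in V0 | has_pair c.2 i j])
        (triple_verts t)) (triple_verts t)) c.1].

Section PatternGraph.
Variables (n : nat) (adj : nat -> nat -> bool).

Definition ptriangle (t : triple) :=
  [&& t.1.1 < n, t.1.2 < n, t.2 < n, adj t.1.1 t.1.2, adj t.1.1 t.2 & adj t.1.2 t.2].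
Definition pedge (p : nat * nat) := [&& p.1 < n, p.2 < n & adj p.1 p.2].

Definition covers (hasX : nat -> nat -> bool) (V0 : seq nat) :=
  all (fun w => all (fun j => all (fun k => [|| hasX w j, hasX w k | hasX j k])
    [seq k <- iota 0 n | adj w k && adj j k]) [seq j <- iota 0 n | adj w j]) V0.

(* Triples and pairs of the template that are not triangles and edges of the
   pattern are discarded, so that one template serves many patterns. *)
Definition certifies (hasX : nat -> nat -> bool) (V0 : seq nat) (c : template) :=
  (size (filter pedge c.2) <= 2 * size (filter ptriangle c.1)) && covers hasX V0.

End PatternGraph.

Lemma triangle_through (T : finType) (e : rel T) (t : {set T}) x :
  is_triangle e t -> x \in t ->
  exists y z, [/\ t = [set x; y; z], e x y, e x z & e y z].
Proof.
case/andP=> /eqP t3 /forall_inP tadj xt.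
have : #|t :\ x| == 2 by rewrite (cardsD1 x) xt add1n in t3; case: t3 => ->.
case/cards2P=> y [z [yz txyz]].
have /setD1P [yx yt] : y \in t :\ x by rewrite txyz !inE eqxx.
have /setD1P [zx zt] : z \in t :\ x by rewrite txyz !inE eqxx orbT.
have adjt a b : a \in t -> b \in t -> a != b -> e a b.
  by move=> ta tb ab; move/forall_inP: (tadj a ta) => /(_ b tb) /implyP; apply.
exists y, z; split; rewrite ?adjt // 1?eq_sym //.
by rewrite -{1}(setD1K xt) txyz setUA.
Qed.

Section Lift.
Variables (T : finType) (e : rel T) (n : nat) (adj : nat -> nat -> bool) (g : nat -> T).
Hypothesis sg : simple_graph e.
Hypothesis g_adj : forall i j, i < n -> j < n -> e (g i) (g j) = adj i j.
Hypothesis g_inj : forall i j, i < n -> j < n -> g i = g j -> i = j.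

Definition gset (s : seq nat) : {set T} := [set x in map g s].

Lemma gsetP s x : reflect (exists2 i, i \in s & x = g i) (x \in gset s).
Proof. by rewrite inE; apply: (iffP mapP). Qed.

Lemma mem_gset s i : i \in s -> g i \in gset s.
Proof. by move=> si; apply/gsetP; exists i. Qed.

Lemma gset_pair i j : gset [:: i; j] = [set g i; g j].
Proof. by apply/setP => x; rewrite !inE. Qed.

Lemma adj_irr i : i < n -> adj i i = false.
Proof. by move=> ilt; rewrite -g_adj //; case: sg => _ ->. Qed.

Lemma adj_sym i j : i < n -> j < n -> adj i j = adj j i.
Proof. by move=> ilt jlt; rewrite -!g_adj //; case: sg => ->. Qed.

Lemma gset_common s1 s2 x : {subset s1 <= gtn n} -> {subset s2 <= gtn n} ->
  x \in gset s1 -> x \in gset s2 -> exists2 i, (i \in s1) && (i \in s2) & x = g i.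
Proof.
move=> lt1 lt2 /gsetP [i si ->] /gsetP [j sj /g_inj eij].
by exists i => //; rewrite si eij ?sj //; [apply: lt1 | apply: lt2].
Qed.

Lemma card_gset s : {subset s <= gtn n} -> uniq s -> #|gset s| = size s.
Proof.
move=> lt us; rewrite cardsE (card_uniqP _) ?size_map //.
by rewrite (map_inj_in_uniq _) // => i j /lt ilt /lt jlt; apply: g_inj.
Qed.

Lemma ptriangle_lt t : ptriangle n adj t -> {subset triple_verts t <= gtn n}.
Proof.
case: t => [[a b] c] /and5P [alt blt clt _ _] i.
by rewrite !inE => /or3P [] /eqP ->.
Qed.

Lemma ptriangle_adj t i j : ptriangle n adj t ->
  i \in triple_verts t -> j \in triple_verts t -> i != j -> adj i j.
Proof.
case: t => [[a b] c] /and5P [alt blt clt ab /andP [ac bc]].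
rewrite !inE => /or3P [] /eqP -> /or3P [] /eqP ->; rewrite ?eqxx // => _;
  by rewrite adj_sym.
Qed.

Lemma ptriangle_uniq t : ptriangle n adj t -> uniq (triple_verts t).
Proof.
case: t => [[a b] c] /and5P /= [alt blt clt ab /andP [ac bc]].
have ne i j : i < n -> adj i j -> i != j.
  by move=> ilt; apply: contraTneq => eij; rewrite -eij adj_irr.
by rewrite !inE !negb_or !ne.
Qed.

Lemma is_triangle_gset t : ptriangle n adj t -> is_triangle e (gset (triple_verts t)).
Proof.
move=> tri; have lt := ptriangle_lt tri.
rewrite /is_triangle card_gset ?ptriangle_uniq //=.
apply/forall_inP => x /gsetP [i it ->]; apply/forall_inP => y /gsetP [j jt ->].
apply/implyP => gij; rewrite g_adj; try exact: lt.
by apply: ptriangle_adj tri it jt _; apply: contraNneq gij => ->.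
Qed.

Lemma is_edge_gset p : pedge n adj p -> is_edge e (gset [:: p.1; p.2]).
Proof.
case/and3P => lt1 lt2 a12; apply/existsP; exists (g p.1); apply/existsP; exists (g p.2).
by rewrite g_adj // a12 gset_pair eqxx.
Qed.

Variables (V0 : seq nat) (c : template) (hasX : nat -> nat -> bool).
Hypothesis V0_lt : {subset V0 <= gtn n}.
Hypothesis V0_nil : V0 != [::].
Hypothesis g_nbhd : forall w y, w \in V0 -> e (g w) y -> exists2 i, i < n & y = g i.
Hypothesis c_ok : template_ok V0 c.
Hypothesis hasX_sub : forall i j, hasX i j -> has_pair c.2 i j.
Hypothesis c_cert : certifies n adj hasX V0 c.

Let S := filter (ptriangle n adj) c.1.
Let X := filter (pedge n adj) c.2.
Definition lifted_triangles := [set x in map (fun t => gset (triple_verts t)) S].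
Definition lifted_edges := [set x in map (fun p => gset [:: p.1; p.2]) X].

Lemma share_edge_eq t1 t2 : t1 \in c.1 -> t2 \in c.1 -> share_edge t1 t2 -> t1 = t2.
Proof.
case/and3P: c_ok => _ /allP disj _ t1c t2c; apply: contraTeq => t12.
by move/allP: (disj _ t1c) => /(_ _ t2c); rewrite (negbTE t12).
Qed.

Lemma share_edge_of_meet t1 t2 : ptriangle n adj t1 -> ptriangle n adj t2 ->
  1 < #|gset (triple_verts t1) :&: gset (triple_verts t2)| -> share_edge t1 t2.
Proof.
move=> tri1 tri2 /card_gt1P [x [y [+ + xy]]]; rewrite !in_setI.
move=> /andP [x1 x2] /andP [y1 y2].
have [lt1 lt2] := (ptriangle_lt tri1, ptriangle_lt tri2).
have [i /andP [i1 i2] exi] := gset_common lt1 lt2 x1 x2.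
have [j /andP [j1 j2] eyj] := gset_common lt1 lt2 y1 y2.
apply/hasP; exists i => //; apply/hasP; exists j => //.
by rewrite i2 j2 !andbT; apply/eqP => ij; move: xy; rewrite exi eyj ij eqxx.
Qed.

Lemma edge_disjoint_lifted : edge_disjoint_triangles e lifted_triangles.
Proof.
split=> [t | t1 t2]; rewrite !inE.
  by case/mapP=> t0; rewrite mem_filter => /andP [tri _] ->; apply: is_triangle_gset.
case/mapP=> t1' + -> /mapP [t2' + ->] ne.
rewrite !mem_filter => /andP [tri1 t1c] /andP [tri2 t2c].
rewrite leqNgt; apply: contra ne => /(share_edge_of_meet tri1 tri2).
by move/(share_edge_eq t1c t2c) ->.
Qed.

Lemma card_lifted_triangles : #|lifted_triangles| = size S.
Proof.
rewrite cardsE (card_uniqP _) ?size_map //; rewrite map_inj_in_uniq.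
  by rewrite filter_uniq //; case/and3P: c_ok.
move=> t1 t2; rewrite !mem_filter => /andP [tri1 t1c] /andP [tri2 t2c] eq12.
apply: share_edge_eq t1c t2c (share_edge_of_meet tri1 tri2 _).
by rewrite eq12 setIid card_gset ?ptriangle_uniq //; apply: ptriangle_lt.
Qed.

Lemma card_lifted_edges : #|lifted_edges| <= 2 * #|lifted_triangles|.
Proof.
rewrite card_lifted_triangles; case/andP: c_cert => size_ok _; apply: leq_trans size_ok.
by rewrite cardsE; apply: leq_trans (card_size _) _; rewrite size_map.
Qed.

Lemma lifted_edge_of_pair i j : i < n -> j < n -> adj i j -> has_pair c.2 i j ->
  [set g i; g j] \in lifted_edges.
Proof.
move=> ilt jlt aij /orP [] pX; rewrite inE; apply/mapP.
  by exists (i, j); rewrite ?gset_pair // mem_filter pX /pedge /= ilt jlt aij.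
exists (j, i); last by rewrite gset_pair setUC.
by rewrite mem_filter pX /pedge /= ilt jlt adj_sym // aij.
Qed.

Lemma lifted_edge_of_triangle (t : {set T}) i j : i < n -> j < n -> adj i j ->
  has_pair c.2 i j -> g i \in t -> g j \in t ->
  exists f, edge_of f t /\ f \in lifted_edges.
Proof.
move=> ilt jlt aij pX it jt; exists [set g i; g j]; split.
  rewrite /edge_of cards2 (_ : g i != g j); last first.
    by apply: contraTneq aij => /g_inj eij; rewrite eij ?adj_irr.
  by rewrite andbT; apply/subsetP => x /set2P [] ->.
exact: lifted_edge_of_pair.
Qed.

Lemma lifted_edges_hit t : is_triangle e t -> t :&: gset V0 != set0 ->
  exists f, edge_of f t /\ f \in lifted_edges.
Proof.
move=> /triangle_through tri /set0Pn [x /setIP [xt /gsetP [w wV0 exw]]]; subst x.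
have [y [z [-> ewy ewz eyz]]] := tri _ xt.
have [j jlt eyj] := g_nbhd wV0 ewy; have [k klt ezk] := g_nbhd wV0 ewz; subst y z.
have wlt := V0_lt wV0.
rewrite !g_adj // in ewy ewz eyz.
case/andP: c_cert => _ /allP /(_ _ wV0) /allP /(_ j).
rewrite mem_filter mem_iota jlt ewy => /(_ isT) /allP /(_ k).
rewrite mem_filter mem_iota klt ewz eyz => /(_ isT).
case/or3P=> /hasX_sub pX; [ apply: (lifted_edge_of_triangle wlt jlt ewy pX)
  | apply: (lifted_edge_of_triangle wlt klt ewz pX)
  | apply: (lifted_edge_of_triangle jlt klt eyz pX) ]; by rewrite !inE eqxx ?orbT.
Qed.

Lemma lifted_edges_outside t f : t \in lifted_triangles -> edge_of f t ->
  f :&: gset V0 = set0 -> f \in lifted_edges.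
Proof.
rewrite inE => /mapP [p]; rewrite mem_filter => /andP [tri pc] ->.
case/andP=> /subsetP fsub /cards2P [x [y [xy fxy]]] fV0.
have /gsetP [i ip exi] : x \in gset (triple_verts p) by apply: fsub; rewrite fxy !inE eqxx.
have /gsetP [j jp eyj] : y \in gset (triple_verts p).
  by apply: fsub; rewrite fxy !inE eqxx orbT.
subst x y; have ij : i != j by apply: contraNneq xy => ->.
have outV0 k : g k \in f -> k \notin V0.
  move=> kf; apply/negP => kV; move/setP: fV0 => /(_ (g k)).
  by rewrite in_setI kf mem_gset // inE.
have pX : has_pair c.2 i j.
  case/and3P: c_ok => _ _ /allP /(_ _ pc) /allP /(_ _ ip) /allP /(_ _ jp).
  by rewrite (negbTE ij) !(negbTE (outV0 _ _)) // fxy !inE eqxx ?orbT.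
by rewrite fxy; apply: lifted_edge_of_pair (ptriangle_lt tri ip) (ptriangle_lt tri jp)
  (ptriangle_adj tri ip jp ij) pX.
Qed.

Theorem reducible_lift : reducible e (gset V0).
Proof.
split.
  case: V0 V0_nil => // w V _; apply/set0Pn; exists (g w); exact: mem_gset (mem_head _ _).
exists lifted_triangles, lifted_edges; split; first exact: edge_disjoint_lifted.
split.
  move=> f; rewrite inE => /mapP [p]; rewrite mem_filter => /andP [ep _] ->.
  exact: is_edge_gset.
split; first exact: card_lifted_edges.
by split; [exact: lifted_edges_hit | exact: lifted_edges_outside].
Qed.

End Lift.

(* The pairs x < y are listed colexicographically, so (x, y) sits at position
   'C(y, 2) + x. *)
Fixpoint pair_bits (n : nat) (f : nat -> nat -> bool) : seq bool :=
  if n is m.+1 then pair_bits m f ++ [seq f x m | x <- iota 0 m] else [::].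

Definition pair_bit (bs : seq bool) (x y : nat) : bool :=
  nth false bs ('C(maxn x y, 2) + minn x y).

Lemma size_pair_bits n f : size (pair_bits n f) = 'C(n, 2).
Proof. by elim: n => //= n IH; rewrite size_cat IH size_map size_iota binS bin1. Qed.

Lemma pair_bit_sym bs x y : pair_bit bs x y = pair_bit bs y x.
Proof. by rewrite /pair_bit maxnC minnC. Qed.

Lemma pair_bit_bits n f x y : x < y < n -> pair_bit (pair_bits n f) x y = f x y.
Proof.
case/andP=> xy; rewrite /pair_bit (maxn_idPr (ltnW xy)) (minn_idPl (ltnW xy)).
elim: n => // n IH; rewrite ltnS leq_eqVlt => /orP [/eqP eyn | yn] /=.
  subst y; rewrite nth_cat size_pair_bits ltnNge leq_addr /= addKn.
  by rewrite (nth_map 0) ?size_iota // nth_iota.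
rewrite nth_cat size_pair_bits ifT ?IH //.
by apply: leq_trans (leq_bin2l 2 yn); rewrite binS bin1 ltn_add2l.
Qed.

Lemma pair_bit_bits_sym n f x y : (forall a b, f a b = f b a) ->
  x != y -> x < n -> y < n -> pair_bit (pair_bits n f) x y = f x y.
Proof.
move=> fsym xy xn yn; case: (ltngtP x y) xy => // [lt | gt] _.
  by rewrite pair_bit_bits ?lt.
by rewrite pair_bit_sym pair_bit_bits ?gt // fsym.
Qed.

Lemma eq_pair_bits n f f' : (forall x y, x < y < n -> f x y = f' x y) ->
  pair_bits n f = pair_bits n f'.
Proof.
elim: n => //= n IH eqf; congr (_ ++ _).
  by apply: IH => x y /andP [xy yn]; rewrite eqf // xy ltnW.
by apply/eq_in_map => x; rewrite mem_iota => /= xn; rewrite eqf // xn /=.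
Qed.

(* The graph H on 0 = u, 1 = v, 2..5 = A and 6.. = B: [ab] codes G[A], the
   row [nth [::] na k] lists the neighbours in A of the k-th vertex of B, and
   [bb] codes G[B]. *)
Definition pattern_adj (ab : seq bool) (na : seq (seq bool)) (bb : seq bool) (i j : nat) :=
  let x := minn i j in let y := maxn i j in
  if x == y then false
  else if x == 0 then true
  else if x == 1 then y < 6
  else if y < 6 then pair_bit ab (x - 2) (y - 2)
  else if x < 6 then nth false (nth [::] na (y - 6)) (x - 2)
  else pair_bit bb (x - 6) (y - 6).

Section PatternBlocks.
Variables (ab : seq bool) (na : seq (seq bool)) (bb : seq bool).

Lemma pattern_adj_sym i j : pattern_adj ab na bb i j = pattern_adj ab na bb j i.
Proof. by rewrite /pattern_adj minnC maxnC. Qed.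

Lemma pattern_adj_small i j : i < 6 -> j < 6 ->
  pattern_adj ab na bb i j = pattern_adj ab [::] [::] i j.
Proof. by move=> i6 j6; rewrite /pattern_adj (_ : maxn i j < 6) //; lia. Qed.

Lemma pattern_adj_lt i j : i < j -> pattern_adj ab na bb i j =
  if i == 0 then true
  else if i == 1 then j < 6
  else if j < 6 then pair_bit ab (i - 2) (j - 2)
  else if i < 6 then nth false (nth [::] na (j - 6)) (i - 2)
  else pair_bit bb (i - 6) (j - 6).
Proof.
by move=> ij; rewrite /pattern_adj (minn_idPl (ltnW ij)) (maxn_idPr (ltnW ij)) ltn_eqF.
Qed.

Lemma pattern_adj_u j : 0 < j -> pattern_adj ab na bb 0 j = true.
Proof. by move=> j0; rewrite pattern_adj_lt. Qed.

Lemma pattern_adj_v j : 1 < j -> pattern_adj ab na bb 1 j = (j < 6).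
Proof. by move=> j1; rewrite pattern_adj_lt. Qed.

Lemma pattern_adj_common i j : i < j < 4 ->
  pattern_adj ab na bb i.+2 j.+2 = pair_bit ab i j.
Proof. by case/andP=> ij j4; rewrite pattern_adj_lt //= ifT ?subn2 //; lia. Qed.

Lemma pattern_adj_cross i j : i < 4 ->
  pattern_adj ab na bb i.+2 (j + 6) = nth false (nth [::] na j) i.
Proof.
move=> i4; rewrite pattern_adj_lt /=; last lia.
by rewrite ifF ?ifT ?addnK ?subn2 //; lia.
Qed.

Lemma pattern_adj_extra i j : i < j ->
  pattern_adj ab na bb (i + 6) (j + 6) = pair_bit bb i j.
Proof. by move=> ij; rewrite pattern_adj_lt ?ltn_add2r // !ifF ?addnK //; lia. Qed.

End PatternBlocks.

Fixpoint bool_seqs k : seq (seq bool) :=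
  if k is k'.+1 then [seq b :: s | b <- [:: false; true], s <- bool_seqs k'] else [:: [::]].

Fixpoint tuples_of (A : Type) (k : nat) (s : seq A) : seq (seq A) :=
  if k is k'.+1 then [seq b :: r | b <- s, r <- tuples_of k' s] else [:: [::]].

Lemma mem_bool_seqs s : s \in bool_seqs (size s).
Proof. by elim: s => [|b s IH] //; apply/allpairsP; exists (b, s); case: b. Qed.

Lemma mem_tuples_of (A : eqType) (s t : seq A) :
  {subset t <= s} -> t \in tuples_of (size t) s.
Proof.
elim: t => [|x t IH] //= ts; apply/allpairsP; exists (x, t); split=> //.
  by apply: ts; rewrite mem_head.
by apply: IH => y yt; apply: ts; rewrite inE yt orbT.
Qed.

Lemma all2_mem (A B : eqType) (r : A -> B -> bool) s t x :
  all2 r s t -> x \in s -> exists2 y, y \in t & r x y.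
Proof.
elim: s t => [|x' s IH] [|y t] //= /andP [rxy rst]; rewrite inE => /orP [/eqP -> | xs].
  by exists y; rewrite ?mem_head.
by have [y' y't rxy'] := IH _ rst xs; exists y'; rewrite ?inE ?y't ?orbT.
Qed.

Fixpoint row_key (s : seq bool) : nat := if s is b :: s' then b + 2 * row_key s' else 0.

(* B may be listed in any order, so only the row sequences sorted by
   decreasing binary value are enumerated. *)
Definition sorted_rows nb :=
  [seq na <- tuples_of nb (bool_seqs 4) | sorted (fun r r' => row_key r' <= row_key r) na].

Definition K4 := nseq 6 true.
Definition K4e := rcons (nseq 5 true) false.

Definition permute (ab : seq bool) (p : seq nat) :=
  pair_bits 4 (fun x y => pair_bit ab (nth 0 p x) (nth 0 p y)).

(* [has_pair X] is tabulated once per template: evaluated afresh at each use,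
   it dominates the running time of [uv_check]. *)
Definition adj_matrix n (f : nat -> nat -> bool) := mkseq (fun i => mkseq (f i) n) n.
Definition madj (m : seq (seq bool)) i j := nth false (nth [::] m i) j.

Lemma madj_adj_matrix n f i j : madj (adj_matrix n f) i j -> f i j.
Proof.
rewrite /madj /adj_matrix; case: (ltnP i n) => [ilt | ige]; last first.
  by rewrite [nth [::] _ _]nth_default ?size_mkseq // nth_nil.
rewrite nth_mkseq //; case: (ltnP j n) => [jlt | jge]; first by rewrite nth_mkseq.
by rewrite nth_default ?size_mkseq.
Qed.

Definition v_check (cs : seq template) :=
  all (template_ok [:: 1]) cs &&
  all (fun ab => has (fun c => certifies 6 (pattern_adj ab [::] [::]) (has_pair c.2) [:: 1] c) cs
      || has (fun p => permute ab p \in [:: K4; K4e]) (permutations (iota 0 4)))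
    (bool_seqs 6).

(* [table] gives, for each of K4 and K4e, each sorted row sequence and each
   graph on B, the index in [cs] of a template certifying {u, v}. *)
Definition uv_check nb (cs : seq template) (table : seq (seq (seq nat))) :=
  let xs := [seq adj_matrix (6 + nb) (has_pair c.2) | c <- cs] in
  all (template_ok [:: 0; 1]) cs &&
  all2 (fun ab row => all2 (fun na r => all2 (fun bb i =>
      certifies (6 + nb) (pattern_adj ab na bb) (madj (nth [::] xs i)) [:: 0; 1]
        (nth ([::], [::]) cs i))
    (bool_seqs 'C(nb, 2)) r) (sorted_rows nb) row) [:: K4; K4e] table.

Lemma uv_checkP nb cs table ab na bb : uv_check nb cs table ->
  ab \in [:: K4; K4e] -> na \in sorted_rows nb -> bb \in bool_seqs 'C(nb, 2) ->
  exists c (hasX : nat -> nat -> bool), [/\ template_ok [:: 0; 1] c,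
    forall i j, hasX i j -> has_pair c.2 i j &
    certifies (6 + nb) (pattern_adj ab na bb) hasX [:: 0; 1] c].
Proof.
case/andP=> /allP cs_ok table_ok abK na_rows bb_bits.
have [row _ /all2_mem /(_ na_rows) [r _ /all2_mem /(_ bb_bits) [i _ c_cert]]] :=
  all2_mem table_ok abK.
exists (nth ([::], [::]) cs i).
exists (madj (nth [::] [seq adj_matrix (6 + nb) (has_pair c.2) | c <- cs] i)).
case: (ltnP i (size cs)) => [ilt | ige]; last first.
  split=> // [|j k]; first by rewrite nth_default.
  by rewrite [nth [::] _ i]nth_default ?size_map // /madj !nth_nil.
split=> // [|j k]; first exact/cs_ok/mem_nth.
by rewrite (nth_map ([::], [::])) // => /madj_adj_matrix.
Qed.

Section Neighbourhood.
Variables (T : finType) (e : rel T) (u v : T).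
Hypothesis sg : simple_graph e.
Hypothesis euv : e u v.
Hypothesis deg_v : deg e v = 5.
Hypothesis u_subsumes_v : subsumes e u v.

(* As N[v] is contained in N[u], [common_nbhd] is the common neighbourhood of u and v. *)
Definition common_nbhd := nbhd e v :\ u.
Definition extra_nbhd := nbhd e u :\: cnbhd e v.

Lemma e_sym : symmetric e. Proof. by case: sg. Qed.
Lemma e_irr x : e x x = false. Proof. by case: sg => _ ->. Qed.

Lemma common_nbhdP x : x \in common_nbhd -> [/\ e u x, e v x & x != u].
Proof.
rewrite !inE => /andP [xu evx]; split=> //.
have /(subsetP u_subsumes_v.2) : x \in cnbhd e v by rewrite !inE evx orbT.
by rewrite !inE (negbTE xu).
Qed.

Lemma extra_nbhdP x : x \in extra_nbhd -> [/\ e u x, e v x = false & x != v].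
Proof. by rewrite !inE negb_or => /andP [/andP [xv /negbTE evx] eux]. Qed.

Lemma nbhd_u_cases y : e u y -> [|| y == v, y \in common_nbhd | y \in extra_nbhd].
Proof.
move=> euy; case: (eqVneq y v) => //= yv; rewrite !inE (negbTE yv) euy /=.
have yu : y != u by apply: contraTneq euy => ->; rewrite e_irr.
by rewrite yu; case: (e v y).
Qed.

Lemma card_common_nbhd : #|common_nbhd| = 4.
Proof.
by move: deg_v; rewrite /deg (cardsD1 u) inE e_sym euv add1n => -[].
Qed.

Lemma card_extra_nbhd : #|extra_nbhd| = deg e u - 5.
Proof.
have meet : nbhd e u :&: cnbhd e v = cnbhd e v :\ u.
  apply/setP => x; rewrite in_setI in_setD1 andbC.
  case xv: (x \in cnbhd e v); rewrite ?andbF //=.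
  have /(subsetP u_subsumes_v.2) := xv; rewrite !inE.
  by case: (eqVneq x u) => [-> | _] //=; rewrite e_irr.
have card_cv : #|cnbhd e v| = 6 by rewrite cardsU1 inE e_irr -/(deg e v) deg_v.
have u_cv : u \in cnbhd e v by rewrite !inE e_sym euv orbT.
rewrite /extra_nbhd cardsD meet; congr (_ - _).
by move: card_cv; rewrite (cardsD1 u) u_cv => -[].
Qed.

Section Ordering.
Variables sa sb : seq T.
Hypothesis sa_perm : perm_eq sa (enum common_nbhd).
Hypothesis sb_perm : perm_eq sb (enum extra_nbhd).

Definition vertex_order := u :: v :: sa ++ sb.
Definition vx (i : nat) : T := nth u vertex_order i.
Definition common_bits := pair_bits 4 (fun i j => e (nth u sa i) (nth u sa j)).
Definition extra_rows := [seq [seq e a b | a <- sa] | b <- sb].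
Definition extra_bits := pair_bits (size sb) (fun i j => e (nth u sb i) (nth u sb j)).

Local Notation nb := (size sb).

Lemma size_sa : size sa = 4.
Proof. by rewrite (perm_size sa_perm) -cardE card_common_nbhd. Qed.

Lemma mem_sa x : (x \in sa) = (x \in common_nbhd).
Proof. by rewrite (perm_mem sa_perm) mem_enum. Qed.

Lemma mem_sb x : (x \in sb) = (x \in extra_nbhd).
Proof. by rewrite (perm_mem sb_perm) mem_enum. Qed.

Lemma uniq_vertex_order : uniq vertex_order.
Proof.
have uA : u \in common_nbhd = false by apply/negP => /common_nbhdP [_ _]; rewrite eqxx.
have vA : v \in common_nbhd = false by apply/negP => /common_nbhdP [_]; rewrite e_irr.
have uB : u \in extra_nbhd = false by apply/negP => /extra_nbhdP []; rewrite e_irr.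
have vB : v \in extra_nbhd = false by apply/negP => /extra_nbhdP [_ _]; rewrite eqxx.
rewrite /vertex_order !cons_uniq !inE !mem_cat !mem_sa !mem_sb uA uB vA vB.
rewrite (negbTE u_subsumes_v.1) cat_uniq (perm_uniq sa_perm) (perm_uniq sb_perm) !enum_uniq /=.
rewrite andbT; apply/hasP => -[x]; rewrite mem_sb mem_sa.
by case/extra_nbhdP=> _ evx _ /common_nbhdP [_]; rewrite evx.
Qed.

Lemma vx_inj i j : i < 6 + nb -> j < 6 + nb -> vx i = vx j -> i = j.
Proof.
have size_order : size vertex_order = 6 + nb by rewrite /= size_cat size_sa.
by move=> ilt jlt /eqP; rewrite /vx nth_uniq ?size_order ?uniq_vertex_order // => /eqP.
Qed.

Lemma vx_common k : k < 4 -> vx k.+2 = nth u sa k.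
Proof. by move=> k4; rewrite /vx /= nth_cat size_sa k4. Qed.

Lemma vx_extra k : vx (k + 6) = nth u sb k.
Proof. by rewrite /vx addnC /= nth_cat size_sa ltnNge leq_addr /= addKn. Qed.

Lemma vx_common_mem k : k < 4 -> vx k.+2 \in common_nbhd.
Proof. by move=> k4; rewrite vx_common // -mem_sa mem_nth ?size_sa. Qed.

Lemma vx_extra_mem k : k < nb -> vx (k + 6) \in extra_nbhd.
Proof. by move=> kb; rewrite vx_extra -mem_sb mem_nth. Qed.

Lemma vx_cases j : j < 6 + nb ->
  [\/ j = 0, j = 1, exists2 k, k < 4 & j = k.+2 | exists2 k, k < nb & j = k + 6].
Proof.
case: j => [|[|j]] jn; [by constructor 1 | by constructor 2 | ].
case: (ltnP j 4) => j4; first by constructor 3; exists j.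
by constructor 4; exists (j - 4); lia.
Qed.

Lemma vx_adj_u j : 0 < j -> j < 6 + nb -> e u (vx j).
Proof.
move=> j0 /vx_cases [|| [k k4] | [k kb]] jE; subst j => //.
- by case/common_nbhdP: (vx_common_mem k4).
- by case/extra_nbhdP: (vx_extra_mem kb).
Qed.

Lemma vx_adj_v j : 1 < j -> j < 6 + nb -> e v (vx j) = (j < 6).
Proof.
move=> j1 /vx_cases [|| [k k4] | [k kb]] jE; subst j => //.
- by case/common_nbhdP: (vx_common_mem k4) => _ -> _; lia.
- by case/extra_nbhdP: (vx_extra_mem kb) => _ -> _; lia.
Qed.

Lemma vx_adj_lt i j : i < j -> j < 6 + nb ->
  e (vx i) (vx j) = pattern_adj common_bits extra_rows extra_bits i j.
Proof.
move=> ij jn; have := vx_cases jn.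
case: (vx_cases (ltn_trans ij jn)) => [|| [k k4] | [k kb]] iE; subst i.
- by move=> _; rewrite pattern_adj_u //; apply: vx_adj_u.
- by move=> _; rewrite pattern_adj_v //; apply: vx_adj_v.
- case=> [|| [l l4] | [l lb]] jE; subst j; try lia.
    by rewrite pattern_adj_common ?vx_common ?pair_bit_bits //; lia.
  by rewrite pattern_adj_cross // vx_common // vx_extra (nth_map u) // (nth_map u) ?size_sa.
- case=> [|| [l l4] | [l lb]] jE; subst j; try lia.
  by rewrite pattern_adj_extra ?vx_extra ?pair_bit_bits //; lia.
Qed.

Lemma vx_adj i j : i < 6 + nb -> j < 6 + nb ->
  e (vx i) (vx j) = pattern_adj common_bits extra_rows extra_bits i j.
Proof.
move=> ilt jlt; case: (ltngtP i j) => [ij | ji | ->]; first exact: vx_adj_lt.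
  by rewrite e_sym pattern_adj_sym vx_adj_lt.
by rewrite e_irr /pattern_adj minnn maxnn eqxx.
Qed.

Lemma vx_nbhd_u y : e u y -> exists2 i, i < 6 + nb & y = vx i.
Proof.
move=> euy; have y_order : y \in vertex_order.
  rewrite /vertex_order !inE mem_cat mem_sa mem_sb.
  by case/or3P: (nbhd_u_cases euy) => ->; rewrite ?orbT.
exists (index y vertex_order); last by rewrite /vx nth_index.
by rewrite (_ : 6 + nb = size vertex_order) ?index_mem // /= size_cat size_sa.
Qed.

Lemma vx_nbhd_v y : e v y -> exists2 i, i < 6 & y = vx i.
Proof.
move=> evy; case: (eqVneq y u) => [-> | yu]; first by exists 0.
have ysa : y \in sa by rewrite mem_sa !inE yu.
have ylt : index y sa < 4 by rewrite -size_sa index_mem.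
by exists (index y sa).+2; rewrite ?vx_common ?nth_index //; lia.
Qed.

Lemma reducible_v_of_certificate c (hasX : nat -> nat -> bool) :
  template_ok [:: 1] c -> (forall i j, hasX i j -> has_pair c.2 i j) ->
  certifies 6 (pattern_adj common_bits [::] [::]) hasX [:: 1] c -> reducible e [set v].
Proof.
move=> c_ok hasX_sub c_cert.
have -> : [set v] = gset vx [:: 1] by apply/setP => x; rewrite !inE.
apply: (reducible_lift sg _ _ _ _ _ c_ok hasX_sub c_cert) => //.
- by move=> i j i6 j6; rewrite vx_adj ?pattern_adj_small //; lia.
- by move=> i j i6 j6; apply: vx_inj; lia.
- by move=> w /[!inE] /eqP ->.
- by move=> w y /[!inE] /eqP ->; apply: vx_nbhd_v.
Qed.

Lemma reducible_uv_of_certificate c (hasX : nat -> nat -> bool) :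
  template_ok [:: 0; 1] c -> (forall i j, hasX i j -> has_pair c.2 i j) ->
  certifies (6 + nb) (pattern_adj common_bits extra_rows extra_bits) hasX [:: 0; 1] c ->
  reducible e [set u; v].
Proof.
move=> c_ok hasX_sub c_cert.
have -> : [set u; v] = gset vx [:: 0; 1] by apply/setP => x; rewrite !inE.
apply: (reducible_lift sg vx_adj vx_inj _ _ _ c_ok hasX_sub c_cert) => //.
- by move=> w /[!inE] /orP [] /eqP ->.
- move=> w y /[!inE] /orP [] /eqP -> => [|/vx_nbhd_v [i i6 ->]]; first exact: vx_nbhd_u.
  by exists i => //; lia.
Qed.

End Ordering.

Lemma extra_order sa : size sa = 4 ->
  exists2 sb, perm_eq sb (enum extra_nbhd) & extra_rows sa sb \in sorted_rows (size sb).
Proof.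
move=> sa4; pose row b := [seq e a b | a <- sa].
pose sb := sort (fun x y => row_key (row y) <= row_key (row x)) (enum extra_nbhd).
exists sb; first by rewrite perm_sort.
rewrite mem_filter; apply/andP; split.
  by rewrite sorted_map; apply: sort_sorted => x y; apply: leq_total.
rewrite -(size_map row); apply: mem_tuples_of => _ /mapP [b _ ->].
by have := mem_bool_seqs (row b); rewrite size_map sa4.
Qed.

Lemma common_order cs : v_check cs -> ~ reducible e [set v] ->
  exists2 sa, perm_eq sa (enum common_nbhd) & common_bits sa \in [:: K4; K4e].
Proof.
case/andP=> /allP cs_ok /allP check not_red_v.
pose sa0 := enum common_nbhd.
have sa0_4 : size sa0 = 4 by rewrite -cardE card_common_nbhd.
case/orP: (check _ (mem_bool_seqs (common_bits sa0))) => [/hasP [c c_in c_cert] | /hasP [p]].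
  case: not_red_v.
  by apply: (reducible_v_of_certificate (sb := enum extra_nbhd) _ _ (cs_ok _ c_in) _ c_cert).
rewrite mem_permutations => p_perm pK; exists (map (nth u sa0) p).
  by rewrite -[enum _](mkseq_nth u sa0) sa0_4; apply: perm_map.
suff -> : common_bits (map (nth u sa0) p) = permute (common_bits sa0) p by [].
apply: eq_pair_bits => x y /andP [xy y4].
have p4 k : k < 4 -> nth 0 p k < 4.
  move=> k4; suff : nth 0 p k \in iota 0 4 by rewrite mem_iota.
  by rewrite -(perm_mem p_perm) mem_nth // (perm_size p_perm) size_iota.
have p_uniq : uniq p by rewrite (perm_uniq p_perm) iota_uniq.
rewrite !(nth_map 0) ?(perm_size p_perm) ?size_iota //; last exact: ltn_trans y4.
rewrite pair_bit_bits_sym ?p4 //; last by rewrite ?p4 ?(ltn_trans xy).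
- by move=> a b; rewrite e_sym.
- by rewrite nth_uniq ?(perm_size p_perm) ?size_iota ?(ltn_trans xy) ?ltn_eqF.
Qed.

End Neighbourhood.

Definition v_templates : seq template := [::
  ([:: (0,1,2)], [:: (0,1); (0,2)]);
  ([:: (0,1,4); (1,2,3)], [:: (0,1); (0,4); (2,3)]);
  ([:: (0,1,3); (1,2,4)], [:: (0,1); (0,3); (2,4)]);
  ([:: (0,1,3); (1,2,4)], [:: (0,1); (0,3); (1,2); (2,4)]);
  ([:: (0,1,3); (1,2,5)], [:: (0,1); (0,3); (2,5)]);
  ([:: (0,1,3); (1,2,5)], [:: (0,1); (0,3); (1,2); (2,5)]);
  ([:: (0,1,2); (1,3,4)], [:: (0,1); (0,2); (3,4)]);
  ([:: (0,1,2); (1,3,4)], [:: (0,1); (0,2); (1,2); (3,4)]);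
  ([:: (0,1,2); (1,3,5)], [:: (0,1); (0,2); (3,5)]);
  ([:: (0,1,2); (1,3,5)], [:: (0,1); (0,2); (1,2); (3,5)]);
  ([:: (0,1,2); (0,3,4); (1,3,5)], [:: (0,1); (0,2); (0,3); (0,4); (3,4); (3,5)]);
  ([:: (0,1,2); (1,3,4)], [:: (0,1); (0,2); (1,3); (3,4)]);
  ([:: (0,1,2); (0,3,5); (1,3,4)], [:: (0,2); (0,3); (0,5); (1,4); (3,4); (3,5)]);
  ([:: (0,1,2); (1,3,5); (2,3,4)], [:: (0,1); (0,2); (2,3); (2,4); (3,4); (3,5)]);
  ([:: (0,1,2); (0,3,4); (1,3,5)], [:: (0,2); (0,3); (0,4); (1,5); (3,4); (3,5)]);
  ([:: (0,1,2); (1,3,4); (2,3,5)], [:: (0,1); (0,2); (2,3); (2,5); (3,4); (3,5)]);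
  ([:: (0,2,4); (0,3,5); (1,2,5); (1,3,4)], [:: (0,2); (0,3); (0,4); (0,5); (2,4); (2,5); (3,4); (3,5)]);
  ([:: (0,1,2); (1,4,5)], [:: (0,1); (0,2); (4,5)]);
  ([:: (0,1,2); (1,4,5)], [:: (0,1); (0,2); (1,2); (4,5)]);
  ([:: (0,1,2); (0,3,4); (1,4,5)], [:: (0,1); (0,2); (0,3); (0,4); (3,4); (4,5)]);
  ([:: (0,1,2); (0,4,5); (1,3,4)], [:: (0,2); (0,4); (0,5); (1,3); (3,4); (4,5)]);
  ([:: (0,1,2); (1,3,4)], [:: (0,1); (0,2); (1,4); (3,4)]);
  ([:: (0,1,2); (1,4,5); (2,3,4)], [:: (0,1); (0,2); (2,3); (2,4); (3,4); (4,5)]);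
  ([:: (0,1,2); (0,3,4); (1,4,5)], [:: (0,2); (0,3); (0,4); (1,5); (3,4); (4,5)]);
  ([:: (0,2,3); (0,4,5); (1,2,5); (1,3,4)], [:: (0,2); (0,3); (0,4); (0,5); (2,3); (2,5); (3,4); (4,5)]);
  ([:: (0,1,2); (1,3,4); (2,4,5)], [:: (0,1); (0,2); (2,4); (2,5); (3,4); (4,5)]);
  ([:: (0,1,2); (0,3,5); (1,4,5)], [:: (0,1); (0,2); (0,3); (0,5); (3,5); (4,5)]);
  ([:: (0,1,2); (0,4,5); (1,3,5)], [:: (0,2); (0,4); (0,5); (1,3); (3,5); (4,5)]);
  ([:: (0,1,2); (0,3,5); (1,4,5)], [:: (0,2); (0,3); (0,5); (1,4); (3,5); (4,5)]);
  ([:: (0,2,3); (0,4,5); (1,2,4); (1,3,5)], [:: (0,2); (0,3); (0,4); (0,5); (2,3); (2,4); (3,5); (4,5)]);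
  ([:: (0,1,2); (1,3,5)], [:: (0,1); (0,2); (1,5); (3,5)]);
  ([:: (0,1,2); (1,4,5); (2,3,5)], [:: (0,1); (0,2); (2,3); (2,5); (3,5); (4,5)]);
  ([:: (0,1,2); (1,3,5); (2,4,5)], [:: (0,1); (0,2); (2,4); (2,5); (3,5); (4,5)])].

Definition uv_templates2 : seq template := [::
  ([:: (0,1,2); (0,3,4); (0,5,6); (1,3,5)], [:: (0,2); (0,3); (0,4); (1,2); (1,5); (3,4); (3,5); (5,6)]);
  ([:: (0,1,2); (0,3,4); (0,5,6); (1,3,5); (2,3,6); (2,4,5)], [:: (0,1); (0,7); (2,3); (2,4); (2,5); (2,6); (3,4); (3,5); (3,6); (4,5); (5,6)]);
  ([:: (0,1,2); (0,3,4); (0,5,6); (1,3,5)], [:: (0,1); (0,2); (0,6); (1,2); (3,4); (3,5); (4,5); (5,6)]);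
  ([:: (0,1,2); (0,3,4); (0,5,6); (1,3,5); (2,4,5)], [:: (0,1); (0,6); (0,7); (2,3); (2,4); (2,5); (3,4); (3,5); (4,5); (5,6)]);
  ([:: (0,1,2); (0,3,4); (0,5,6); (1,4,5)], [:: (0,1); (0,2); (0,6); (0,7); (1,2); (3,4); (4,5); (5,6)]);
  ([:: (0,1,2); (0,3,4); (0,5,6); (1,3,5); (2,3,7); (2,4,5)], [:: (0,1); (0,6); (2,3); (2,4); (2,5); (2,7); (3,4); (3,5); (3,7); (4,5); (5,6)]);
  ([:: (0,1,2); (0,3,4); (0,6,7); (1,3,5)], [:: (0,2); (0,3); (0,4); (1,2); (1,5); (3,4); (3,5); (6,7)]);
  ([:: (0,1,2); (0,3,5); (0,4,6); (1,4,5)], [:: (0,1); (0,2); (0,6); (0,7); (1,2); (3,5); (4,5); (4,6)]);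
  ([:: (0,1,2); (0,3,4); (0,5,6); (1,3,5)], [:: (0,1); (0,2); (0,7); (1,2); (3,4); (3,5); (4,5); (5,6)]);
  ([:: (0,1,2); (0,3,4); (0,5,6); (1,3,5); (4,5,7)], [:: (0,1); (0,2); (0,6); (1,2); (3,4); (3,5); (4,5); (4,7); (5,6); (5,7)]);
  ([:: (0,1,2); (0,3,4); (0,5,6); (1,3,5)], [:: (0,1); (0,2); (0,6); (0,7); (1,2); (3,4); (3,5); (5,6)]);
  ([:: (0,1,2); (0,3,5); (0,4,6); (1,3,4)], [:: (0,1); (0,2); (0,3); (1,2); (3,4); (3,5); (4,5); (4,6)]);
  ([:: (0,1,2); (0,3,5); (0,4,6); (1,3,4)], [:: (0,2); (0,3); (0,4); (1,2); (1,5); (3,4); (3,5); (4,6)]);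
  ([:: (0,1,2); (0,3,4); (0,5,6); (1,3,5)], [:: (0,3); (0,4); (0,7); (1,2); (1,5); (3,4); (3,5); (5,6)]);
  ([:: (0,1,2); (0,3,5); (0,4,7); (1,4,5)], [:: (0,1); (0,2); (0,6); (1,2); (3,5); (4,5); (4,7)]);
  ([:: (0,1,2); (0,3,4); (0,5,6); (1,3,5)], [:: (0,3); (0,5); (0,6); (1,2); (1,4); (3,4); (3,5); (5,6)]);
  ([:: (0,1,2); (0,3,4); (0,6,7); (1,4,5)], [:: (0,1); (0,2); (0,3); (0,4); (1,2); (3,4); (4,5); (6,7)]);
  ([:: (0,1,2); (0,3,6); (0,4,5); (1,3,4)], [:: (0,1); (0,2); (1,2); (3,4); (3,5); (3,6); (4,5)]);
  ([:: (0,1,2); (0,3,4); (0,5,6); (1,3,5)], [:: (0,2); (0,4); (0,7); (1,3); (1,5); (3,4); (3,5); (5,6)]);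
  ([:: (0,1,2); (0,3,4); (0,5,6); (1,3,5); (2,3,6)], [:: (0,1); (0,4); (0,7); (1,4); (2,3); (2,6); (3,4); (3,5); (3,6); (5,6)]);
  ([:: (0,1,2); (0,3,4); (0,6,7); (1,4,5)], [:: (0,3); (0,4); (0,5); (1,2); (3,4); (4,5); (6,7)]);
  ([:: (0,1,2); (0,3,4); (0,5,6); (1,3,5); (2,4,6)], [:: (0,1); (0,7); (2,3); (2,4); (2,6); (3,4); (3,5); (4,5); (4,6); (5,6)]);
  ([:: (0,1,2); (0,3,5); (0,4,6); (1,3,4)], [:: (0,1); (0,2); (1,2); (3,4); (3,5); (4,5); (4,6)]);
  ([:: (0,1,2); (0,3,6); (0,4,5); (1,3,4)], [:: (0,1); (0,2); (0,3); (0,4); (1,2); (3,4); (3,6); (4,5)]);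
  ([:: (0,1,2); (0,3,4); (0,5,6); (1,4,5); (2,3,5)], [:: (0,1); (0,6); (0,7); (2,3); (2,5); (3,4); (3,5); (4,5); (5,6)]);
  ([:: (0,1,2); (0,3,5); (0,4,7); (1,4,5)], [:: (0,1); (0,2); (0,3); (0,6); (1,2); (3,5); (4,5); (4,7)]);
  ([:: (0,1,2); (0,3,5); (0,6,7); (1,4,5)], [:: (0,1); (0,2); (0,3); (0,5); (1,2); (3,5); (4,5); (6,7)]);
  ([:: (0,1,2); (0,3,5); (0,4,6); (1,4,5)], [:: (0,3); (0,4); (0,5); (1,2); (3,5); (4,5); (4,6)]);
  ([:: (0,1,2); (0,3,5); (0,6,7); (1,4,5)], [:: (0,1); (0,2); (0,3); (1,2); (3,5); (4,5); (6,7)]);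
  ([:: (0,1,2); (0,3,7); (0,4,5); (1,3,5)], [:: (0,1); (0,2); (0,5); (1,2); (3,5); (3,7); (4,5)]);
  ([:: (0,1,2); (0,3,7); (0,4,5); (1,3,4)], [:: (0,1); (0,2); (0,4); (1,2); (3,4); (3,7); (4,5)]);
  ([:: (0,1,2); (0,3,5); (1,4,5); (2,3,4)], [:: (0,1); (0,2); (0,3); (2,3); (2,4); (3,4); (3,5); (4,5)]);
  ([:: (0,1,2); (0,3,4); (1,3,5); (2,4,5)], [:: (0,1); (0,3); (1,2); (2,4); (2,5); (3,4); (3,5); (4,5)]);
  ([:: (0,1,2); (0,3,6); (0,4,5); (1,3,5)], [:: (0,1); (0,2); (0,5); (1,2); (3,5); (3,6); (4,5)])].

Definition uv_templates3 : seq template := [::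
  ([:: (0,1,2); (0,3,5); (0,4,6); (0,7,8); (1,3,4)], [:: (0,1); (0,2); (0,6); (0,7); (1,2); (3,4); (3,5); (4,5); (4,6); (7,8)]);
  ([:: (0,1,2); (0,3,4); (0,5,7); (0,6,8); (1,3,5)], [:: (0,1); (0,2); (0,6); (0,8); (1,2); (3,4); (3,5); (4,5); (5,7); (6,8)]);
  ([:: (0,1,2); (0,3,5); (0,4,6); (0,7,8); (1,3,4)], [:: (0,2); (0,3); (0,4); (0,6); (1,2); (1,5); (3,4); (3,5); (4,6); (7,8)]);
  ([:: (0,1,2); (0,3,5); (0,4,7); (0,6,8); (1,3,4)], [:: (0,2); (0,3); (0,4); (0,6); (1,2); (1,5); (3,4); (3,5); (4,7); (6,8)]);
  ([:: (0,1,2); (0,3,4); (0,5,6); (0,7,8); (1,3,5)], [:: (0,2); (0,3); (0,4); (0,5); (1,2); (1,4); (3,4); (3,5); (5,6); (7,8)]);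
  ([:: (0,1,2); (0,3,4); (0,5,6); (0,7,8); (1,3,5); (2,4,5)], [:: (0,1); (0,6); (0,7); (0,8); (2,3); (2,4); (2,5); (3,4); (3,5); (4,5); (5,6); (7,8)]);
  ([:: (0,1,2); (0,3,5); (0,4,6); (0,7,8); (1,4,5)], [:: (0,3); (0,4); (0,5); (0,6); (1,2); (3,5); (4,5); (4,6); (7,8)]);
  ([:: (0,1,2); (0,3,4); (0,6,7); (1,4,5); (2,3,5); (2,4,8)], [:: (0,1); (0,6); (0,7); (2,3); (2,4); (2,5); (2,8); (3,4); (3,5); (4,5); (4,8); (6,7)]);
  ([:: (0,1,2); (0,3,4); (0,5,6); (0,7,8); (1,3,5)], [:: (0,2); (0,3); (0,5); (0,6); (1,2); (1,4); (3,4); (3,5); (5,6); (7,8)]);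
  ([:: (0,1,2); (0,3,4); (0,5,7); (0,6,8); (1,3,5)], [:: (0,2); (0,3); (0,4); (0,6); (1,2); (1,5); (3,4); (3,5); (5,7); (6,8)]);
  ([:: (0,1,2); (0,3,4); (0,5,6); (1,3,5)], [:: (0,2); (0,3); (0,4); (1,2); (1,5); (3,4); (3,5); (5,6)]);
  ([:: (0,1,2); (0,3,4); (0,5,6); (0,7,8); (1,4,5)], [:: (0,2); (0,3); (0,4); (0,5); (1,2); (3,4); (4,5); (5,6); (7,8)]);
  ([:: (0,1,2); (0,3,4); (0,6,7); (1,4,5)], [:: (0,1); (0,2); (0,6); (0,7); (1,2); (3,4); (4,5); (6,7)]);
  ([:: (0,1,2); (0,3,4); (0,5,6); (0,7,8); (1,3,5)], [:: (0,2); (0,3); (0,4); (0,7); (1,2); (1,5); (3,4); (3,5); (5,6); (7,8)]);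
  ([:: (0,1,2); (0,3,4); (0,6,8); (1,3,5); (2,4,5)], [:: (0,1); (0,6); (0,7); (2,3); (2,4); (2,5); (3,4); (3,5); (4,5); (6,8)]);
  ([:: (0,1,2); (0,3,4); (0,6,8); (1,4,5)], [:: (0,3); (0,4); (0,5); (0,7); (1,2); (3,4); (4,5); (6,8)]);
  ([:: (0,1,2); (0,3,4); (0,5,6); (1,4,5); (2,3,5)], [:: (0,1); (0,6); (0,7); (0,8); (2,3); (2,5); (3,4); (3,5); (4,5); (5,6)]);
  ([:: (0,1,2); (0,3,5); (0,4,8); (0,6,7); (1,3,4)], [:: (0,2); (0,3); (0,4); (0,5); (1,2); (1,4); (3,4); (3,5); (4,8); (6,7)]);
  ([:: (0,1,2); (0,3,4); (0,5,6); (0,7,8); (1,3,5)], [:: (0,1); (0,2); (0,7); (0,8); (1,2); (3,4); (3,5); (4,5); (5,6); (7,8)]);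
  ([:: (0,1,2); (0,3,4); (0,5,6); (0,7,8); (1,3,5)], [:: (0,3); (0,4); (0,5); (0,6); (1,2); (1,4); (3,4); (3,5); (5,6); (7,8)]);
  ([:: (0,1,2); (0,3,5); (0,4,8); (0,6,7); (1,4,5)], [:: (0,2); (0,3); (0,4); (0,5); (1,2); (3,5); (4,5); (4,8); (6,7)]);
  ([:: (0,1,2); (0,3,4); (0,6,8); (1,3,5); (2,3,8); (2,4,5)], [:: (0,1); (0,6); (0,7); (2,3); (2,4); (2,5); (2,8); (3,4); (3,5); (3,8); (4,5); (6,8)]);
  ([:: (0,1,2); (0,3,4); (0,7,8); (1,4,5)], [:: (0,3); (0,4); (0,5); (0,6); (1,2); (3,4); (4,5); (7,8)]);
  ([:: (0,1,2); (0,3,5); (0,4,7); (0,6,8); (1,3,4)], [:: (0,1); (0,2); (0,6); (1,2); (3,4); (3,5); (4,5); (4,7); (6,8)]);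
  ([:: (0,1,2); (0,3,5); (0,4,8); (1,4,5)], [:: (0,1); (0,2); (0,6); (0,7); (1,2); (3,5); (4,5); (4,8)]);
  ([:: (0,1,3); (0,2,4); (0,5,6); (1,4,5); (2,3,5); (3,4,6)], [:: (0,1); (0,2); (0,7); (2,3); (2,4); (2,5); (3,4); (3,5); (3,6); (4,5); (4,6); (5,6)]);
  ([:: (0,1,2); (0,3,5); (0,4,6); (1,4,5); (3,4,7)], [:: (0,1); (0,2); (0,6); (1,2); (3,4); (3,5); (3,7); (4,5); (4,6); (4,7)]);
  ([:: (0,1,2); (0,3,5); (0,4,6); (0,7,8); (1,4,5)], [:: (0,1); (0,2); (0,3); (0,6); (1,2); (3,5); (4,5); (4,6); (7,8)]);
  ([:: (0,1,2); (0,3,4); (0,5,7); (0,6,8); (1,3,5)], [:: (0,2); (0,3); (0,5); (1,2); (1,4); (3,4); (3,5); (5,7); (6,8)]);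
  ([:: (0,1,2); (0,3,6); (0,4,8); (0,5,7); (1,3,4)], [:: (0,2); (0,3); (0,4); (0,5); (1,2); (1,5); (3,4); (3,6); (4,8); (5,7)]);
  ([:: (0,1,2); (0,3,5); (0,4,6); (1,4,5)], [:: (0,1); (0,2); (0,6); (0,7); (1,2); (3,5); (4,5); (4,6)]);
  ([:: (0,1,2); (0,3,5); (0,4,6); (0,7,8); (1,4,5)], [:: (0,1); (0,2); (0,6); (0,7); (0,8); (1,2); (3,5); (4,5); (4,6); (7,8)]);
  ([:: (0,1,2); (0,3,5); (0,4,7); (0,6,8); (1,4,5)], [:: (0,1); (0,2); (0,3); (0,4); (0,6); (1,2); (3,5); (4,5); (4,7); (6,8)]);
  ([:: (0,1,2); (0,3,4); (0,5,6); (0,7,8); (1,4,5)], [:: (0,1); (0,2); (0,3); (0,5); (0,6); (1,2); (3,4); (4,5); (5,6); (7,8)]);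
  ([:: (0,1,2); (0,3,5); (0,4,6); (1,3,4)], [:: (0,2); (0,3); (0,4); (1,2); (1,5); (3,4); (3,5); (4,6)]);
  ([:: (0,1,2); (0,3,4); (0,6,7); (1,4,5)], [:: (0,2); (0,3); (0,4); (0,5); (1,2); (3,4); (4,5); (6,7)]);
  ([:: (0,1,2); (0,3,4); (0,5,6); (0,7,8); (1,4,5)], [:: (0,1); (0,2); (0,6); (0,7); (0,8); (1,2); (3,4); (4,5); (5,6); (7,8)]);
  ([:: (0,1,2); (0,3,4); (0,5,7); (0,6,8); (1,3,5)], [:: (0,2); (0,3); (0,5); (0,6); (1,2); (1,4); (3,4); (3,5); (5,7); (6,8)]);
  ([:: (0,1,2); (0,3,4); (0,5,7); (1,3,5); (2,4,5)], [:: (0,1); (0,6); (0,8); (2,3); (2,4); (2,5); (3,4); (3,5); (4,5); (5,7)]);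
  ([:: (0,1,2); (0,3,4); (0,6,7); (1,3,5)], [:: (0,2); (0,3); (0,4); (1,2); (1,5); (3,4); (3,5); (6,7)]);
  ([:: (0,1,2); (0,3,4); (0,5,6); (0,7,8); (1,3,5)], [:: (0,1); (0,2); (0,6); (0,7); (0,8); (1,2); (3,4); (3,5); (5,6); (7,8)]);
  ([:: (0,1,2); (0,3,5); (0,4,6); (0,7,8); (1,4,5)], [:: (0,1); (0,2); (0,4); (0,6); (1,2); (3,5); (4,5); (4,6); (7,8)]);
  ([:: (0,1,2); (0,3,5); (0,4,6); (1,4,5); (2,3,4)], [:: (0,1); (0,6); (0,7); (0,8); (2,3); (2,4); (3,4); (3,5); (4,5); (4,6)]);
  ([:: (0,1,2); (0,3,4); (0,5,6); (1,4,5); (3,5,7)], [:: (0,1); (0,2); (0,6); (1,2); (3,4); (3,5); (3,7); (4,5); (5,6); (5,7)]);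
  ([:: (0,1,2); (0,3,4); (0,6,7); (1,4,5)], [:: (0,3); (0,4); (0,5); (0,8); (1,2); (3,4); (4,5); (6,7)]);
  ([:: (0,1,2); (0,3,4); (0,5,7); (0,6,8); (1,4,5)], [:: (0,2); (0,3); (0,4); (0,5); (1,2); (3,4); (4,5); (5,7); (6,8)]);
  ([:: (0,1,2); (0,3,4); (0,6,7); (1,4,5)], [:: (0,3); (0,4); (0,5); (0,7); (1,2); (3,4); (4,5); (6,7)]);
  ([:: (0,1,2); (0,3,5); (0,7,8); (1,4,5)], [:: (0,2); (0,3); (0,4); (0,5); (1,2); (3,5); (4,5); (7,8)]);
  ([:: (0,1,2); (0,3,4); (0,5,6); (0,7,8); (1,3,5)], [:: (0,2); (0,3); (0,4); (0,6); (1,2); (1,5); (3,4); (3,5); (5,6); (7,8)]);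
  ([:: (0,1,2); (0,3,5); (0,6,8); (1,4,5)], [:: (0,2); (0,3); (0,4); (0,5); (1,2); (3,5); (4,5); (6,8)]);
  ([:: (0,1,2); (0,3,4); (0,6,7); (1,4,5)], [:: (0,3); (0,4); (0,5); (0,6); (1,2); (3,4); (4,5); (6,7)]);
  ([:: (0,1,2); (0,3,4); (0,6,7); (1,3,5)], [:: (0,2); (0,3); (0,5); (1,2); (1,4); (3,4); (3,5); (6,7)]);
  ([:: (0,1,2); (0,3,4); (0,6,8); (1,4,5)], [:: (0,1); (0,2); (0,6); (0,7); (1,2); (3,4); (4,5); (6,8)]);
  ([:: (0,1,2); (0,3,4); (0,6,8); (1,4,5); (2,6,7)], [:: (0,3); (0,4); (0,5); (1,2); (2,6); (2,7); (3,4); (4,5); (6,7); (6,8)]);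
  ([:: (0,1,2); (0,3,4); (0,5,8); (0,6,7); (1,3,5)], [:: (0,2); (0,3); (0,4); (0,5); (1,2); (1,4); (3,4); (3,5); (5,8); (6,7)]);
  ([:: (0,1,2); (0,3,5); (0,4,6); (0,7,8); (1,3,4)], [:: (0,1); (0,2); (0,3); (0,6); (1,2); (3,4); (3,5); (4,5); (4,6); (7,8)]);
  ([:: (0,1,2); (0,3,5); (0,4,6); (1,4,5); (2,3,4); (2,5,8)], [:: (0,1); (0,6); (0,7); (2,3); (2,4); (2,5); (2,8); (3,4); (3,5); (4,5); (4,6); (5,8)]);
  ([:: (0,1,2); (0,3,4); (0,5,6); (0,7,8); (1,3,5); (2,3,6)], [:: (0,1); (0,4); (0,7); (0,8); (1,4); (2,3); (2,6); (3,4); (3,5); (3,6); (5,6); (7,8)]);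
  ([:: (0,1,2); (0,3,6); (0,4,7); (1,3,4); (2,3,7); (2,4,5)], [:: (0,1); (0,6); (0,8); (2,3); (2,4); (2,5); (2,7); (3,4); (3,6); (3,7); (4,5); (4,7)]);
  ([:: (0,1,2); (0,3,5); (0,6,7); (1,4,5)], [:: (0,3); (0,4); (0,5); (0,8); (1,2); (3,5); (4,5); (6,7)]);
  ([:: (0,1,2); (0,3,4); (0,6,7); (1,3,5); (2,3,8); (2,4,5)], [:: (0,1); (0,6); (0,7); (2,3); (2,4); (2,5); (2,8); (3,4); (3,5); (3,8); (4,5); (6,7)]);
  ([:: (0,1,2); (0,3,4); (0,5,6); (1,4,5)], [:: (0,1); (0,2); (0,7); (0,8); (1,2); (3,4); (4,5); (5,6)]);
  ([:: (0,1,2); (0,3,4); (0,5,7); (0,6,8); (1,3,5)], [:: (0,1); (0,2); (0,3); (0,6); (1,2); (3,4); (3,5); (4,5); (5,7); (6,8)]);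
  ([:: (0,1,2); (0,3,4); (0,6,7); (1,4,5); (2,3,5); (2,4,7)], [:: (0,1); (0,3); (0,6); (2,3); (2,4); (2,5); (2,7); (3,4); (3,5); (4,5); (4,7); (6,7)]);
  ([:: (0,1,2); (0,3,4); (0,6,7); (1,3,5)], [:: (0,3); (0,4); (0,5); (1,2); (1,4); (3,4); (3,5); (6,7)]);
  ([:: (0,1,2); (0,3,4); (0,6,8); (1,3,5)], [:: (0,2); (0,3); (0,4); (1,2); (1,5); (3,4); (3,5); (6,8)]);
  ([:: (0,1,2); (0,3,4); (0,6,8); (1,4,5); (2,7,8)], [:: (0,3); (0,4); (0,5); (1,2); (2,7); (2,8); (3,4); (4,5); (6,8); (7,8)]);
  ([:: (0,1,2); (0,3,5); (0,4,6); (1,4,5)], [:: (0,3); (0,4); (0,5); (0,8); (1,2); (3,5); (4,5); (4,6)]);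
  ([:: (0,1,2); (0,3,5); (0,6,8); (1,4,5)], [:: (0,3); (0,4); (0,5); (0,7); (1,2); (3,5); (4,5); (6,8)]);
  ([:: (0,1,2); (0,3,4); (0,5,7); (1,4,5)], [:: (0,1); (0,2); (0,6); (0,8); (1,2); (3,4); (4,5); (5,7)]);
  ([:: (0,1,2); (0,3,4); (0,5,7); (0,6,8); (1,3,5)], [:: (0,3); (0,4); (0,5); (0,6); (1,2); (1,4); (3,4); (3,5); (5,7); (6,8)]);
  ([:: (0,1,2); (0,3,4); (0,5,7); (0,6,8); (1,3,5)], [:: (0,2); (0,3); (0,4); (0,5); (1,2); (1,4); (3,4); (3,5); (5,7); (6,8)]);
  ([:: (0,1,2); (0,3,6); (0,4,7); (0,5,8); (1,3,4)], [:: (0,2); (0,3); (0,4); (0,5); (1,2); (1,5); (3,4); (3,6); (4,7); (5,8)]);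
  ([:: (0,1,2); (0,3,4); (0,5,6); (1,3,5)], [:: (0,2); (0,3); (0,4); (0,5); (1,2); (3,4); (3,5); (5,6)]);
  ([:: (0,1,2); (0,3,4); (0,5,7); (1,4,5); (2,3,5); (2,4,7)], [:: (0,1); (0,6); (0,8); (2,3); (2,4); (2,5); (2,7); (3,4); (3,5); (4,5); (4,7); (5,7)]);
  ([:: (0,1,2); (0,3,6); (0,4,5); (0,7,8); (1,3,4)], [:: (0,1); (0,2); (0,3); (0,4); (0,6); (1,2); (3,4); (3,6); (4,5); (7,8)]);
  ([:: (0,1,2); (0,3,6); (0,4,5); (0,7,8); (1,3,5)], [:: (0,1); (0,2); (0,3); (0,5); (0,6); (1,2); (3,5); (3,6); (4,5); (7,8)]);
  ([:: (0,1,2); (0,3,4); (0,5,6); (1,3,5)], [:: (0,3); (0,4); (0,5); (1,2); (1,4); (3,4); (3,5); (5,6)]);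
  ([:: (0,1,2); (0,3,4); (0,5,6); (0,7,8); (1,3,5)], [:: (0,3); (0,4); (0,7); (0,8); (1,2); (1,5); (3,4); (3,5); (5,6); (7,8)]);
  ([:: (0,1,2); (0,3,4); (0,6,7); (1,4,5); (2,7,8)], [:: (0,3); (0,4); (0,5); (1,2); (2,7); (2,8); (3,4); (4,5); (6,7); (7,8)]);
  ([:: (0,1,2); (0,3,4); (0,5,6); (1,4,5); (2,3,5); (2,4,6)], [:: (0,1); (0,7); (0,8); (2,3); (2,4); (2,5); (2,6); (3,4); (3,5); (4,5); (4,6); (5,6)]);
  ([:: (0,1,2); (0,3,5); (0,4,7); (1,4,5)], [:: (0,1); (0,2); (0,3); (0,6); (1,2); (3,5); (4,5); (4,7)]);
  ([:: (0,1,2); (0,3,4); (0,7,8); (1,3,5)], [:: (0,2); (0,3); (0,4); (1,2); (1,5); (3,4); (3,5); (7,8)]);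
  ([:: (0,1,2); (0,3,5); (0,4,6); (1,4,5); (2,3,4); (2,5,7)], [:: (0,1); (0,6); (0,8); (2,3); (2,4); (2,5); (2,7); (3,4); (3,5); (4,5); (4,6); (5,7)]);
  ([:: (0,1,2); (0,3,4); (0,5,7); (1,3,5); (2,3,7); (2,4,5)], [:: (0,1); (0,6); (0,8); (2,3); (2,4); (2,5); (2,7); (3,4); (3,5); (3,7); (4,5); (5,7)]);
  ([:: (0,1,2); (0,3,5); (0,4,7); (0,6,8); (1,4,5)], [:: (0,1); (0,2); (0,3); (0,6); (0,8); (1,2); (3,5); (4,5); (4,7); (6,8)]);
  ([:: (0,1,2); (0,3,6); (0,5,7); (1,3,5); (2,3,7); (2,4,5)], [:: (0,1); (0,6); (0,8); (2,3); (2,4); (2,5); (2,7); (3,5); (3,6); (3,7); (4,5); (5,7)]);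
  ([:: (0,1,2); (0,3,4); (0,7,8); (1,4,5); (2,6,8)], [:: (0,3); (0,4); (0,5); (1,2); (2,6); (2,8); (3,4); (4,5); (6,8); (7,8)]);
  ([:: (0,1,2); (0,3,5); (0,4,6); (1,4,5); (2,3,4); (2,5,7)], [:: (0,1); (0,3); (0,6); (2,3); (2,4); (2,5); (2,7); (3,4); (3,5); (4,5); (4,6); (5,7)]);
  ([:: (0,1,2); (0,3,6); (0,4,5); (1,3,4)], [:: (0,1); (0,2); (0,3); (1,2); (1,3); (3,4); (3,6); (4,5)]);
  ([:: (0,1,2); (0,3,4); (0,5,6); (0,7,8); (1,3,5)], [:: (0,1); (0,2); (0,3); (0,7); (1,2); (3,4); (3,5); (4,5); (5,6); (7,8)]);
  ([:: (0,1,2); (0,3,4); (0,6,7); (1,4,5); (2,6,8)], [:: (0,3); (0,4); (0,5); (1,2); (2,6); (2,8); (3,4); (4,5); (6,7); (6,8)]);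
  ([:: (0,1,2); (0,3,4); (0,6,7); (1,3,5); (2,3,7); (2,4,5)], [:: (0,1); (0,6); (0,8); (2,3); (2,4); (2,5); (2,7); (3,4); (3,5); (3,7); (4,5); (6,7)]);
  ([:: (0,1,2); (0,3,4); (0,5,6); (1,4,5); (3,5,7)], [:: (0,1); (0,2); (0,4); (1,2); (3,4); (3,5); (3,7); (4,5); (5,6); (5,7)]);
  ([:: (0,1,2); (0,3,7); (0,4,5); (1,3,4)], [:: (0,1); (0,2); (0,3); (0,4); (1,2); (3,4); (3,7); (4,5)]);
  ([:: (0,1,2); (0,3,5); (0,4,7); (1,4,5)], [:: (0,2); (0,3); (0,4); (0,5); (1,2); (3,5); (4,5); (4,7)]);
  ([:: (0,1,2); (0,3,5); (0,4,7); (0,6,8); (1,4,5)], [:: (0,1); (0,2); (0,5); (0,6); (0,8); (1,2); (3,5); (4,5); (4,7); (6,8)]);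
  ([:: (0,1,2); (0,3,4); (0,5,8); (1,4,5); (3,5,7)], [:: (0,1); (0,2); (0,6); (1,2); (3,4); (3,5); (3,7); (4,5); (5,7); (5,8)]);
  ([:: (0,1,2); (0,3,5); (0,6,8); (1,4,5); (2,6,7)], [:: (0,3); (0,4); (0,5); (1,2); (2,6); (2,7); (3,5); (4,5); (6,7); (6,8)]);
  ([:: (0,1,2); (0,3,5); (0,4,7); (1,4,5)], [:: (0,1); (0,2); (0,6); (0,8); (1,2); (3,5); (4,5); (4,7)]);
  ([:: (0,1,2); (0,3,4); (0,5,7); (0,6,8); (1,3,5)], [:: (0,1); (0,2); (0,4); (0,6); (0,8); (1,2); (3,4); (3,5); (5,7); (6,8)]);
  ([:: (0,1,2); (0,3,5); (0,4,6); (1,4,5)], [:: (0,1); (0,2); (0,3); (0,5); (1,2); (3,5); (4,5); (4,6)]);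
  ([:: (0,1,2); (0,3,4); (0,5,6); (1,3,5); (4,6,7)], [:: (0,1); (0,2); (0,3); (1,2); (3,4); (3,5); (4,6); (4,7); (5,6); (6,7)]);
  ([:: (0,1,2); (0,3,5); (0,6,7); (1,4,5)], [:: (0,1); (0,2); (0,3); (0,6); (1,2); (3,5); (4,5); (6,7)]);
  ([:: (0,1,2); (0,3,5); (0,6,7); (1,4,5); (2,3,4)], [:: (0,1); (0,2); (0,3); (0,6); (2,3); (2,4); (3,4); (3,5); (4,5); (6,7)]);
  ([:: (0,1,2); (0,3,5); (0,4,7); (1,4,5); (2,3,4)], [:: (0,1); (0,2); (0,3); (0,6); (2,3); (2,4); (3,4); (3,5); (4,5); (4,7)]);
  ([:: (0,1,2); (0,3,5); (0,4,8); (0,6,7); (1,4,5)], [:: (0,1); (0,2); (0,3); (0,5); (0,7); (1,2); (3,5); (4,5); (4,8); (6,7)]);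
  ([:: (0,1,2); (0,3,5); (0,4,7); (0,6,8); (1,4,5)], [:: (0,1); (0,2); (0,5); (0,7); (1,2); (3,5); (4,5); (4,7); (6,8)]);
  ([:: (0,1,2); (0,3,4); (0,5,7); (0,6,8); (1,4,5)], [:: (0,1); (0,2); (0,4); (0,6); (0,8); (1,2); (3,4); (4,5); (5,7); (6,8)]);
  ([:: (0,1,2); (0,3,4); (0,5,7); (0,6,8); (1,4,5)], [:: (0,1); (0,2); (0,3); (0,4); (0,6); (1,2); (3,4); (4,5); (5,7); (6,8)]);
  ([:: (0,1,2); (0,3,5); (0,6,7); (1,4,5); (2,3,4)], [:: (0,1); (0,2); (0,3); (0,8); (2,3); (2,4); (3,4); (3,5); (4,5); (6,7)]);
  ([:: (0,1,2); (0,3,4); (0,6,8); (1,3,5); (2,3,6); (2,4,5)], [:: (0,1); (0,7); (2,3); (2,4); (2,5); (2,6); (3,4); (3,5); (3,6); (4,5); (6,8)]);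
  ([:: (0,1,2); (0,3,5); (0,6,7); (1,4,5)], [:: (0,1); (0,2); (0,5); (0,8); (1,2); (3,5); (4,5); (6,7)]);
  ([:: (0,1,2); (0,3,7); (0,4,5); (1,3,5)], [:: (0,1); (0,2); (0,3); (0,5); (1,2); (3,5); (3,7); (4,5)]);
  ([:: (0,1,2); (0,3,4); (0,6,7); (1,3,5)], [:: (0,2); (0,3); (0,4); (0,5); (1,2); (3,4); (3,5); (6,7)]);
  ([:: (0,1,2); (0,3,5); (0,4,8); (1,3,4)], [:: (0,2); (0,3); (0,5); (1,2); (1,4); (3,4); (3,5); (4,8)]);
  ([:: (0,1,2); (0,3,5); (0,6,7); (1,4,5); (2,6,8)], [:: (0,3); (0,4); (0,5); (1,2); (2,6); (2,8); (3,5); (4,5); (6,7); (6,8)]);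
  ([:: (0,1,2); (0,3,4); (0,5,7); (0,6,8); (1,3,5)], [:: (0,1); (0,2); (0,6); (0,7); (0,8); (1,2); (3,4); (3,5); (5,7); (6,8)]);
  ([:: (0,1,2); (0,3,4); (0,6,7); (1,4,5); (3,5,6)], [:: (0,1); (0,2); (0,7); (1,2); (3,4); (3,5); (3,6); (4,5); (5,6); (6,7)]);
  ([:: (0,1,2); (0,3,4); (0,5,7); (0,6,8); (1,3,5); (2,4,5)], [:: (0,1); (0,4); (0,6); (0,8); (2,3); (2,4); (2,5); (3,4); (3,5); (4,5); (5,7); (6,8)]);
  ([:: (0,1,2); (0,3,4); (0,6,7); (1,4,5)], [:: (0,1); (0,2); (0,3); (0,6); (1,2); (3,4); (4,5); (6,7)]);
  ([:: (0,1,2); (0,3,4); (0,6,7); (1,3,5); (2,4,5); (2,7,8)], [:: (0,1); (0,6); (2,3); (2,4); (2,5); (2,7); (2,8); (3,4); (3,5); (4,5); (6,7); (7,8)]);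
  ([:: (0,1,2); (0,3,4); (0,5,8); (1,4,5); (2,3,5); (2,4,8)], [:: (0,1); (0,6); (0,7); (2,3); (2,4); (2,5); (2,8); (3,4); (3,5); (4,5); (4,8); (5,8)]);
  ([:: (0,1,2); (0,3,5); (0,4,7); (1,4,5); (3,7,8)], [:: (0,1); (0,2); (0,6); (1,2); (3,5); (3,7); (3,8); (4,5); (4,7); (7,8)]);
  ([:: (0,1,2); (0,3,4); (0,5,7); (0,6,8); (1,4,5)], [:: (0,1); (0,2); (0,3); (0,5); (0,6); (1,2); (3,4); (4,5); (5,7); (6,8)]);
  ([:: (0,1,2); (0,3,4); (0,6,7); (1,4,5); (2,3,5); (2,4,6)], [:: (0,1); (0,3); (0,8); (2,3); (2,4); (2,5); (2,6); (3,4); (3,5); (4,5); (4,6); (6,7)]);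
  ([:: (0,1,2); (0,3,4); (0,6,7); (1,4,5)], [:: (0,1); (0,2); (0,4); (0,8); (1,2); (3,4); (4,5); (6,7)]);
  ([:: (0,1,2); (0,3,4); (0,6,8); (1,3,5); (2,3,7); (2,4,5)], [:: (0,1); (0,6); (0,8); (2,3); (2,4); (2,5); (2,7); (3,4); (3,5); (3,7); (4,5); (6,8)]);
  ([:: (0,1,2); (0,3,4); (0,6,7); (1,4,5)], [:: (0,1); (0,2); (0,4); (0,6); (1,2); (3,4); (4,5); (6,7)]);
  ([:: (0,1,2); (0,3,4); (0,6,7); (1,4,5); (2,3,8); (2,4,7)], [:: (0,1); (0,6); (2,3); (2,4); (2,5); (2,7); (2,8); (3,4); (3,8); (4,5); (4,7); (6,7)]);
  ([:: (0,1,2); (0,3,6); (0,4,5); (1,3,5)], [:: (0,1); (0,2); (0,3); (0,5); (1,2); (3,5); (3,6); (4,5)]);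
  ([:: (0,1,2); (0,3,6); (0,4,5); (1,3,4)], [:: (0,1); (0,2); (0,3); (0,4); (1,2); (3,4); (3,6); (4,5)]);
  ([:: (0,1,2); (0,3,8); (0,4,5); (1,3,5)], [:: (0,1); (0,2); (0,5); (1,2); (3,5); (3,8); (4,5)]);
  ([:: (0,1,2); (0,3,4); (0,6,7); (1,3,5); (2,5,6)], [:: (0,3); (0,4); (1,2); (1,5); (2,5); (2,6); (3,4); (3,5); (5,6); (6,7)]);
  ([:: (0,1,2); (0,3,4); (0,6,8); (1,4,5); (2,3,5); (2,4,6)], [:: (0,1); (0,3); (0,7); (2,3); (2,4); (2,5); (2,6); (3,4); (3,5); (4,5); (4,6); (6,8)]);
  ([:: (0,1,2); (0,3,4); (0,5,6); (1,3,5); (2,3,8); (2,4,5)], [:: (0,1); (0,6); (0,7); (2,3); (2,4); (2,5); (2,8); (3,4); (3,5); (3,8); (4,5); (5,6)]);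
  ([:: (0,1,2); (0,3,5); (0,6,8); (1,4,5); (2,3,4)], [:: (0,1); (0,2); (0,3); (0,7); (2,3); (2,4); (3,4); (3,5); (4,5); (6,8)]);
  ([:: (0,1,2); (0,3,4); (0,5,6); (1,3,5); (2,4,5)], [:: (0,2); (0,4); (0,5); (1,3); (2,4); (2,5); (3,4); (3,5); (4,5); (5,6)]);
  ([:: (0,1,2); (0,3,5); (0,6,8); (1,4,5)], [:: (0,1); (0,2); (0,5); (0,8); (1,2); (3,5); (4,5); (6,8)]);
  ([:: (0,1,2); (0,3,5); (0,6,7); (1,4,5)], [:: (0,1); (0,2); (0,5); (0,6); (1,2); (3,5); (4,5); (6,7)]);
  ([:: (0,1,2); (0,3,5); (0,4,8); (1,4,5); (2,3,8); (2,5,7)], [:: (0,1); (0,6); (2,3); (2,4); (2,5); (2,7); (2,8); (3,5); (3,8); (4,5); (4,8); (5,7)]);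
  ([:: (0,1,2); (0,3,7); (0,4,5); (0,6,8); (1,3,5)], [:: (0,1); (0,2); (0,3); (0,5); (0,6); (1,2); (3,5); (3,7); (4,5); (6,8)]);
  ([:: (0,1,2); (0,3,7); (0,4,5); (0,6,8); (1,3,4)], [:: (0,1); (0,2); (0,3); (0,4); (0,6); (1,2); (3,4); (3,7); (4,5); (6,8)]);
  ([:: (0,1,2); (0,3,4); (0,6,7); (1,4,5); (3,7,8)], [:: (0,1); (0,2); (0,6); (1,2); (3,4); (3,7); (3,8); (4,5); (6,7); (7,8)]);
  ([:: (0,1,2); (0,3,4); (0,6,8); (1,4,5)], [:: (0,1); (0,2); (0,4); (0,7); (1,2); (3,4); (4,5); (6,8)]);
  ([:: (0,1,2); (0,3,6); (0,4,5); (1,3,4)], [:: (0,1); (0,2); (1,2); (3,4); (3,5); (3,6); (4,5)]);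
  ([:: (0,1,2); (0,3,8); (0,4,5); (1,3,4)], [:: (0,1); (0,2); (0,4); (1,2); (3,4); (3,8); (4,5)]);
  ([:: (0,1,2); (0,3,4); (0,6,8); (1,3,5); (2,4,5); (3,7,8)], [:: (0,1); (0,6); (2,3); (2,4); (2,5); (3,4); (3,5); (3,7); (3,8); (4,5); (6,8); (7,8)]);
  ([:: (0,1,2); (0,3,4); (0,5,8); (1,3,5); (2,3,8); (2,4,5)], [:: (0,1); (0,6); (0,7); (2,3); (2,4); (2,5); (2,8); (3,4); (3,5); (3,8); (4,5); (5,8)]);
  ([:: (0,1,2); (0,3,5); (0,7,8); (1,4,5); (2,6,8)], [:: (0,3); (0,4); (0,5); (1,2); (2,6); (2,8); (3,5); (4,5); (6,8); (7,8)]);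
  ([:: (0,1,2); (0,3,5); (0,6,7); (1,4,5)], [:: (0,3); (0,4); (0,5); (0,6); (1,2); (3,5); (4,5); (6,7)]);
  ([:: (0,1,2); (0,3,5); (0,4,8); (0,6,7); (1,4,5)], [:: (0,1); (0,2); (0,3); (0,5); (0,8); (1,2); (3,5); (4,5); (4,8); (6,7)]);
  ([:: (0,1,2); (0,3,4); (0,6,7); (1,4,5); (2,3,5)], [:: (0,1); (0,2); (0,3); (0,6); (2,3); (2,5); (3,4); (3,5); (4,5); (6,7)]);
  ([:: (0,1,2); (0,3,4); (0,6,8); (1,4,5); (2,3,5)], [:: (0,1); (0,2); (0,3); (0,7); (2,3); (2,5); (3,4); (3,5); (4,5); (6,8)]);
  ([:: (0,1,2); (0,3,4); (0,5,7); (0,6,8); (1,3,5); (2,3,6); (2,4,5)], [:: (0,1); (0,6); (0,7); (0,8); (2,3); (2,4); (2,5); (2,6); (3,4); (3,5); (3,6); (4,5); (5,7); (6,8)]);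
  ([:: (0,1,2); (0,3,4); (0,6,7); (1,3,5); (2,4,5)], [:: (0,1); (0,2); (0,3); (0,6); (2,4); (2,5); (3,4); (3,5); (4,5); (6,7)]);
  ([:: (0,1,2); (0,3,5); (0,4,6); (1,4,5); (2,3,8); (2,5,7)], [:: (0,1); (0,6); (2,3); (2,4); (2,5); (2,7); (2,8); (3,5); (3,8); (4,5); (4,6); (5,7)]);
  ([:: (0,1,2); (0,3,4); (0,5,7); (0,6,8); (1,4,5)], [:: (0,1); (0,2); (0,6); (0,7); (0,8); (1,2); (3,4); (4,5); (5,7); (6,8)]);
  ([:: (0,1,2); (0,3,4); (0,6,8); (1,3,5); (2,4,5); (2,7,8)], [:: (0,1); (0,6); (2,3); (2,4); (2,5); (2,7); (2,8); (3,4); (3,5); (4,5); (6,8); (7,8)]);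
  ([:: (0,1,2); (0,3,4); (0,6,8); (1,3,5); (4,5,6)], [:: (0,1); (0,2); (0,3); (1,2); (3,4); (3,5); (4,5); (4,6); (5,6); (6,8)]);
  ([:: (0,1,2); (0,3,4); (0,5,6); (1,3,5); (2,3,8); (2,4,5)], [:: (0,1); (0,4); (0,7); (2,3); (2,4); (2,5); (2,8); (3,4); (3,5); (3,8); (4,5); (5,6)]);
  ([:: (0,1,2); (0,3,5); (0,4,7); (0,6,8); (1,4,5)], [:: (0,1); (0,2); (0,3); (0,5); (0,6); (1,2); (3,5); (4,5); (4,7); (6,8)]);
  ([:: (0,1,2); (0,3,4); (0,6,8); (1,3,5); (3,6,7); (4,5,6)], [:: (0,1); (0,2); (1,2); (3,4); (3,5); (3,6); (3,7); (4,5); (4,6); (5,6); (6,7); (6,8)]);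
  ([:: (0,1,2); (0,3,5); (0,4,7); (0,6,8); (1,4,5)], [:: (0,1); (0,2); (0,6); (0,7); (0,8); (1,2); (3,5); (4,5); (4,7); (6,8)]);
  ([:: (0,1,2); (0,3,5); (0,4,6); (1,3,4); (2,4,5)], [:: (0,1); (0,7); (0,8); (2,3); (2,4); (2,5); (3,4); (3,5); (4,5); (4,6)]);
  ([:: (0,1,2); (0,3,4); (0,5,7); (1,3,5); (2,4,5)], [:: (0,1); (0,3); (0,6); (1,2); (2,4); (2,5); (3,4); (3,5); (4,5); (5,7)]);
  ([:: (0,1,2); (0,3,4); (0,5,7); (1,4,5); (2,3,5); (2,4,7)], [:: (0,1); (0,3); (0,6); (2,3); (2,4); (2,5); (2,7); (3,4); (3,5); (4,5); (4,7); (5,7)]);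
  ([:: (0,1,2); (0,3,4); (0,5,7); (1,3,5); (2,5,6)], [:: (0,3); (0,4); (1,2); (1,5); (2,5); (2,6); (3,4); (3,5); (5,6); (5,7)]);
  ([:: (0,1,2); (0,3,4); (0,6,8); (1,4,5); (3,7,8)], [:: (0,1); (0,2); (0,6); (1,2); (3,4); (3,7); (3,8); (4,5); (6,8); (7,8)]);
  ([:: (0,1,2); (0,3,4); (0,5,6); (1,4,5); (2,3,5); (2,4,6)], [:: (0,1); (0,3); (0,7); (2,3); (2,4); (2,5); (2,6); (3,4); (3,5); (4,5); (4,6); (5,6)]);
  ([:: (0,1,2); (0,3,4); (0,6,8); (1,3,5); (2,3,6); (2,4,5)], [:: (0,1); (0,2); (0,7); (2,3); (2,4); (2,5); (2,6); (3,4); (3,5); (3,6); (4,5); (6,8)]);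
  ([:: (0,1,2); (0,3,5); (0,6,7); (1,4,5); (3,6,8)], [:: (0,1); (0,2); (0,5); (1,2); (3,5); (3,6); (3,8); (4,5); (6,7); (6,8)]);
  ([:: (0,1,2); (0,3,6); (0,4,5); (0,7,8); (1,3,5)], [:: (0,1); (0,2); (0,5); (0,8); (1,2); (3,5); (3,6); (4,5); (7,8)]);
  ([:: (0,1,2); (0,3,4); (0,6,7); (1,3,5); (2,3,6); (2,4,5)], [:: (0,1); (0,7); (0,8); (2,3); (2,4); (2,5); (2,6); (3,4); (3,5); (3,6); (4,5); (6,7)]);
  ([:: (0,1,2); (0,3,5); (0,4,8); (0,6,7); (1,4,5)], [:: (0,1); (0,2); (0,3); (0,5); (0,6); (1,2); (3,5); (4,5); (4,8); (6,7)]);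
  ([:: (0,1,2); (0,3,4); (0,5,6); (1,3,5); (2,4,5); (2,6,8)], [:: (0,1); (0,7); (2,3); (2,4); (2,5); (2,6); (2,8); (3,4); (3,5); (4,5); (5,6); (6,8)]);
  ([:: (0,1,2); (0,3,4); (0,6,8); (1,4,5)], [:: (0,3); (0,4); (0,5); (0,8); (1,2); (3,4); (4,5); (6,8)]);
  ([:: (0,1,2); (0,3,4); (0,6,7); (1,3,5); (2,4,5)], [:: (0,2); (0,4); (0,5); (1,3); (2,4); (2,5); (3,4); (3,5); (4,5); (6,7)]);
  ([:: (0,1,2); (0,3,4); (0,6,7); (1,3,5); (4,5,6)], [:: (0,1); (0,2); (0,3); (1,2); (3,4); (3,5); (4,5); (4,6); (5,6); (6,7)]);
  ([:: (0,1,2); (0,3,4); (0,7,8); (1,4,5); (2,3,8); (2,4,7)], [:: (0,1); (0,6); (2,3); (2,4); (2,5); (2,7); (2,8); (3,4); (3,8); (4,5); (4,7); (7,8)]);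
  ([:: (0,1,2); (0,3,4); (0,6,7); (1,4,5); (2,3,5); (2,4,6)], [:: (0,1); (0,3); (0,7); (2,3); (2,4); (2,5); (2,6); (3,4); (3,5); (4,5); (4,6); (6,7)]);
  ([:: (0,1,2); (0,3,4); (0,5,6); (1,3,5); (2,3,6); (2,4,5)], [:: (0,1); (0,7); (0,8); (2,3); (2,4); (2,5); (2,6); (3,4); (3,5); (3,6); (4,5); (5,6)]);
  ([:: (0,1,2); (0,3,5); (0,4,6); (1,3,4); (2,4,5); (3,6,7)], [:: (0,1); (0,8); (2,3); (2,4); (2,5); (3,4); (3,5); (3,6); (3,7); (4,5); (4,6); (6,7)]);
  ([:: (0,1,2); (0,3,5); (0,6,8); (1,4,5)], [:: (0,3); (0,4); (0,5); (0,8); (1,2); (3,5); (4,5); (6,8)]);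
  ([:: (0,1,2); (0,3,4); (0,6,8); (1,3,5); (4,5,6)], [:: (0,1); (0,2); (0,7); (1,2); (3,4); (3,5); (4,5); (4,6); (5,6); (6,8)]);
  ([:: (0,1,2); (0,3,4); (0,5,6); (1,3,5); (2,4,6)], [:: (0,3); (0,5); (1,2); (1,4); (2,4); (2,6); (3,4); (3,5); (4,6); (5,6)]);
  ([:: (0,1,2); (0,3,4); (0,6,8); (1,4,5)], [:: (0,1); (0,2); (0,4); (0,8); (1,2); (3,4); (4,5); (6,8)]);
  ([:: (0,1,2); (0,3,4); (0,5,6); (1,3,5); (2,4,5); (3,6,7)], [:: (0,1); (0,8); (2,3); (2,4); (2,5); (3,4); (3,5); (3,6); (3,7); (4,5); (5,6); (6,7)]);
  ([:: (0,1,2); (0,3,4); (0,6,8); (1,3,5); (2,4,5)], [:: (0,1); (0,3); (0,8); (1,2); (2,4); (2,5); (3,4); (3,5); (4,5); (6,8)]);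
  ([:: (0,1,2); (0,3,4); (0,6,7); (1,4,5); (2,3,5)], [:: (0,1); (0,2); (0,3); (0,7); (2,3); (2,5); (3,4); (3,5); (4,5); (6,7)])].

Definition uv_table2 : seq (seq (seq nat)) := [::
  [:: [:: 1; 1]; [:: 0; 1]; [:: 1; 1]; [:: 0; 1]; [:: 0; 1]; [:: 0; 1]; [:: 0; 1]; [:: 0; 1];
     [:: 0; 1]; [:: 0; 1]; [:: 5; 5]; [:: 12; 6]; [:: 11; 6]; [:: 11; 6]; [:: 5; 5]; [:: 0; 2];
     [:: 3; 3]; [:: 0; 3]; [:: 3; 3]; [:: 0; 3]; [:: 3; 3]; [:: 0; 3]; [:: 0; 2]; [:: 3; 3];
     [:: 0; 3]; [:: 0; 3]; [:: 3; 3]; [:: 0; 3]; [:: 5; 5]; [:: 32; 6]; [:: 17; 6]; [:: 0; 1];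
     [:: 1; 1]; [:: 0; 1]; [:: 0; 1]; [:: 1; 1]; [:: 0; 1]; [:: 0; 1]; [:: 1; 1]; [:: 0; 1];
     [:: 0; 1]; [:: 0; 1]; [:: 5; 5]; [:: 12; 6]; [:: 11; 6]; [:: 12; 6]; [:: 11; 6]; [:: 12; 6];
     [:: 5; 5]; [:: 0; 2]; [:: 3; 3]; [:: 0; 3]; [:: 3; 3]; [:: 0; 3]; [:: 3; 3]; [:: 0; 3];
     [:: 3; 3]; [:: 0; 2]; [:: 3; 3]; [:: 0; 3]; [:: 3; 3]; [:: 0; 3]; [:: 3; 3]; [:: 0; 3];
     [:: 5; 5]; [:: 17; 6]; [:: 0; 1]; [:: 1; 1]; [:: 0; 1]; [:: 0; 1]; [:: 0; 1]; [:: 0; 1];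
     [:: 1; 1]; [:: 0; 1]; [:: 0; 1]; [:: 0; 1]; [:: 5; 5]; [:: 12; 6]; [:: 11; 6]; [:: 11; 6];
     [:: 12; 6]; [:: 5; 5]; [:: 0; 2]; [:: 3; 3]; [:: 0; 3]; [:: 3; 3]; [:: 0; 3]; [:: 3; 3];
     [:: 0; 3]; [:: 0; 2]; [:: 3; 3]; [:: 0; 3]; [:: 3; 3]; [:: 0; 3]; [:: 3; 3]; [:: 0; 3];
     [:: 1; 1]; [:: 1; 1]; [:: 1; 1]; [:: 1; 1]; [:: 0; 1]; [:: 1; 1]; [:: 0; 1]; [:: 0; 1];
     [:: 1; 1]; [:: 0; 1]; [:: 0; 1]; [:: 1; 1]; [:: 0; 1]; [:: 0; 1]; [:: 1; 1]; [:: 0; 1];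
     [:: 5; 5]; [:: 12; 6]; [:: 11; 6]; [:: 12; 6]; [:: 11; 6]; [:: 12; 6]; [:: 5; 5]; [:: 12; 6];
     [:: 0; 2]; [:: 3; 3]; [:: 0; 3]; [:: 3; 3]; [:: 0; 3]; [:: 3; 3]; [:: 0; 3]; [:: 3; 3];
     [:: 0; 2]; [:: 3; 3]; [:: 0; 3]; [:: 3; 3]; [:: 0; 3]; [:: 3; 3]; [:: 0; 3]; [:: 3; 3]];
  [:: [:: 2; 2]; [:: 0; 1]; [:: 1; 1]; [:: 0; 1]; [:: 0; 1]; [:: 0; 1]; [:: 0; 1]; [:: 0; 1];
     [:: 0; 1]; [:: 0; 1]; [:: 2; 2]; [:: 12; 6]; [:: 11; 6]; [:: 2; 2]; [:: 11; 6]; [:: 0; 2];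
     [:: 9; 9]; [:: 0; 9]; [:: 10; 10]; [:: 0; 10]; [:: 10; 10]; [:: 0; 10]; [:: 0; 2]; [:: 9; 9];
     [:: 0; 9]; [:: 0; 5]; [:: 10; 10]; [:: 0; 10]; [:: 2; 2]; [:: 11; 6]; [:: 2; 2]; [:: 0; 2];
     [:: 9; 9]; [:: 0; 9]; [:: 0; 10]; [:: 10; 10]; [:: 0; 10]; [:: 0; 2]; [:: 9; 9]; [:: 0; 9];
     [:: 0; 5]; [:: 0; 10]; [:: 2; 2]; [:: 12; 6]; [:: 11; 6]; [:: 12; 6]; [:: 2; 2]; [:: 12; 6];
     [:: 11; 6]; [:: 0; 2]; [:: 9; 9]; [:: 0; 9]; [:: 10; 10]; [:: 0; 10]; [:: 10; 10]; [:: 0; 10];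
     [:: 10; 10]; [:: 0; 2]; [:: 9; 9]; [:: 0; 9]; [:: 10; 10]; [:: 0; 5]; [:: 10; 10]; [:: 0; 10];
     [:: 2; 2]; [:: 2; 2]; [:: 0; 2]; [:: 8; 8]; [:: 0; 8]; [:: 0; 8]; [:: 0; 8]; [:: 0; 2];
     [:: 8; 8]; [:: 0; 8]; [:: 0; 5]; [:: 0; 8]; [:: 2; 2]; [:: 12; 6]; [:: 11; 6]; [:: 2; 2];
     [:: 12; 6]; [:: 11; 6]; [:: 0; 2]; [:: 9; 9]; [:: 0; 9]; [:: 10; 10]; [:: 0; 10]; [:: 10; 10];
     [:: 0; 10]; [:: 0; 2]; [:: 9; 9]; [:: 0; 9]; [:: 10; 10]; [:: 0; 5]; [:: 10; 10]; [:: 0; 10];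
     [:: 2; 2]; [:: 11; 6]; [:: 2; 2]; [:: 11; 6]; [:: 0; 1]; [:: 1; 1]; [:: 0; 1]; [:: 0; 1];
     [:: 1; 1]; [:: 0; 1]; [:: 0; 1]; [:: 1; 1]; [:: 0; 1]; [:: 0; 1]; [:: 1; 1]; [:: 0; 1];
     [:: 2; 2]; [:: 12; 6]; [:: 11; 6]; [:: 12; 6]; [:: 2; 2]; [:: 12; 6]; [:: 11; 6]; [:: 12; 6];
     [:: 0; 2]; [:: 9; 9]; [:: 0; 9]; [:: 10; 10]; [:: 0; 10]; [:: 10; 10]; [:: 0; 10]; [:: 10; 10];
     [:: 0; 2]; [:: 9; 9]; [:: 0; 9]; [:: 10; 10]; [:: 0; 5]; [:: 10; 10]; [:: 0; 10]; [:: 10; 10]]].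

Definition uv_table3 : seq (seq (seq nat)) := [::
  [:: [:: 111; 82; 14; 14; 7; 7; 7; 7]; [:: 10; 4; 14; 5; 7; 5; 7; 5]; [:: 25; 4; 1; 1; 7; 5; 1; 1];
     [:: 28; 4; 1; 1; 38; 5; 1; 1]; [:: 38; 4; 1; 1; 17; 5; 1; 1]; [:: 28; 4; 1; 1; 38; 5; 1; 1];
     [:: 38; 4; 1; 1; 17; 5; 1; 1]; [:: 25; 4; 1; 1; 25; 5; 1; 1]; [:: 38; 4; 1; 1; 7; 5; 1; 1];
     [:: 28; 4; 1; 1; 38; 5; 1; 1]; [:: 38; 4; 1; 1; 17; 5; 1; 1]; [:: 10; 4; 3; 5; 7; 5; 3; 5];
     [:: 10; 4; 3; 5; 17; 5; 3; 5]; [:: 10; 4; 3; 5; 64; 5; 3; 5]; [:: 10; 4; 3; 5; 23; 5; 3; 5];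
     [:: 10; 4; 3; 5; 60; 5; 3; 5]; [:: 10; 4; 14; 5; 7; 5; 7; 5]; [:: 10; 4; 28; 5; 51; 5; 63; 5];
     [:: 10; 4; 28; 5; 25; 5; 80; 5]; [:: 10; 4; 3; 5; 7; 5; 3; 5]; [:: 10; 4; 3; 5; 17; 5; 3; 5];
     [:: 10; 4; 3; 5; 64; 5; 3; 5]; [:: 10; 4; 3; 5; 17; 5; 3; 5]; [:: 10; 4; 3; 5; 25; 5; 3; 5];
     [:: 10; 4; 3; 5; 7; 5; 3; 5]; [:: 10; 4; 3; 5; 60; 5; 3; 5]; [:: 10; 4; 14; 5; 7; 5; 7; 5];
     [:: 10; 4; 23; 5; 25; 5; 23; 5]; [:: 10; 4; 3; 5; 7; 5; 3; 5]; [:: 10; 4; 3; 5; 17; 5; 3; 5];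
     [:: 10; 4; 3; 5; 63; 5; 3; 5]; [:: 10; 4; 3; 5; 23; 5; 3; 5]; [:: 10; 4; 3; 5; 7; 5; 3; 5];
     [:: 10; 4; 3; 5; 60; 5; 3; 5]; [:: 10; 4; 14; 5; 7; 5; 7; 5]; [:: 10; 4; 28; 5; 51; 5; 80; 5];
     [:: 10; 4; 28; 5; 25; 5; 80; 5]; [:: 10; 4; 21; 5; 51; 5; 21; 5]; [:: 10; 4; 3; 5; 7; 5; 3; 5];
     [:: 10; 4; 3; 5; 17; 5; 3; 5]; [:: 10; 4; 3; 5; 63; 5; 3; 5]; [:: 10; 4; 3; 5; 17; 5; 3; 5];
     [:: 10; 4; 3; 5; 25; 5; 3; 5]; [:: 10; 4; 3; 5; 7; 5; 3; 5]; [:: 10; 4; 3; 5; 60; 5; 3; 5];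
     [:: 10; 4; 3; 5; 17; 5; 3; 5]; [:: 26; 0; 14; 0; 7; 0; 7; 0]; [:: 23; 0; 3; 0; 7; 0; 3; 0];
     [:: 34; 2; 3; 2; 17; 2; 3; 2]; [:: 34; 2; 3; 2; 39; 2; 3; 2]; [:: 23; 0; 3; 0; 23; 0; 3; 0];
     [:: 34; 2; 3; 2; 39; 2; 3; 2]; [:: 34; 0; 14; 0; 7; 0; 7; 0]; [:: 34; 2; 65; 2; 39; 2; 63; 2];
     [:: 34; 0; 65; 0; 39; 0; 164; 0]; [:: 26; 0; 14; 0; 7; 0; 7; 0]; [:: 26; 0; 23; 0; 26; 0; 23; 0];
     [:: 34; 0; 14; 0; 7; 0; 7; 0]; [:: 34; 2; 65; 2; 39; 2; 92; 2]; [:: 34; 0; 65; 0; 39; 0; 92; 0];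
     [:: 34; 2; 21; 2; 39; 2; 21; 2]; [:: 10; 0; 14; 0; 7; 0; 7; 0]; [:: 38; 0; 1; 0; 7; 0; 1; 0];
     [:: 38; 4; 1; 1; 38; 5; 1; 1]; [:: 38; 4; 1; 1; 17; 5; 1; 1]; [:: 38; 4; 1; 1; 38; 5; 1; 1];
     [:: 38; 4; 1; 1; 17; 5; 1; 1]; [:: 38; 0; 1; 0; 38; 0; 1; 0]; [:: 38; 4; 1; 1; 7; 5; 1; 1];
     [:: 38; 4; 1; 1; 38; 5; 1; 1]; [:: 38; 4; 1; 1; 17; 5; 1; 1]; [:: 10; 0; 3; 0; 7; 0; 3; 0];
     [:: 10; 2; 3; 2; 17; 2; 3; 2]; [:: 10; 2; 3; 2; 64; 2; 3; 2]; [:: 10; 0; 3; 0; 23; 0; 3; 0];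
     [:: 10; 2; 3; 2; 60; 2; 3; 2]; [:: 56; 0; 9; 0; 7; 0; 7; 0]; [:: 77; 4; 70; 5; 54; 5; 70; 5];
     [:: 77; 4; 9; 5; 17; 5; 9; 5]; [:: 77; 4; 70; 5; 17; 5; 70; 5]; [:: 77; 4; 9; 5; 64; 5; 9; 5];
     [:: 77; 4; 70; 5; 54; 5; 70; 5]; [:: 77; 4; 9; 5; 17; 5; 9; 5]; [:: 137; 0; 9; 0; 177; 0; 9; 0];
     [:: 56; 4; 56; 5; 54; 5; 56; 5]; [:: 137; 4; 9; 5; 7; 5; 7; 5]; [:: 135; 4; 9; 5; 60; 5; 9; 5];
     [:: 148; 4; 71; 5; 54; 5; 119; 5]; [:: 160; 4; 9; 5; 17; 5; 9; 5]; [:: 10; 0; 14; 0; 7; 0; 7; 0];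
     [:: 10; 2; 88; 2; 63; 2; 63; 2]; [:: 10; 0; 159; 0; 178; 0; 184; 0]; [:: 43; 0; 9; 0; 7; 0; 7; 0];
     [:: 77; 4; 37; 5; 54; 5; 37; 5]; [:: 77; 4; 9; 5; 17; 5; 9; 5]; [:: 77; 4; 9; 5; 64; 5; 9; 5];
     [:: 77; 4; 37; 5; 54; 5; 37; 5]; [:: 77; 4; 9; 5; 17; 5; 9; 5]; [:: 43; 0; 9; 0; 43; 0; 9; 0];
     [:: 56; 4; 37; 5; 54; 5; 37; 5]; [:: 93; 4; 9; 5; 7; 5; 7; 5]; [:: 135; 4; 9; 5; 60; 5; 9; 5];
     [:: 160; 4; 9; 5; 17; 5; 9; 5]; [:: 10; 0; 3; 0; 7; 0; 3; 0]; [:: 10; 2; 3; 2; 17; 2; 3; 2];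
     [:: 10; 2; 3; 2; 64; 2; 3; 2]; [:: 10; 2; 3; 2; 17; 2; 3; 2]; [:: 10; 0; 3; 0; 26; 0; 3; 0];
     [:: 10; 2; 3; 2; 7; 2; 3; 2]; [:: 10; 2; 3; 2; 60; 2; 3; 2]; [:: 10; 0; 14; 0; 7; 0; 7; 0];
     [:: 10; 0; 23; 0; 26; 0; 23; 0]; [:: 56; 0; 1; 0; 7; 0; 1; 0]; [:: 83; 4; 1; 1; 54; 5; 1; 1];
     [:: 83; 4; 1; 1; 17; 5; 1; 1]; [:: 83; 4; 1; 1; 83; 5; 1; 1]; [:: 83; 4; 1; 1; 17; 5; 1; 1];
     [:: 83; 0; 1; 0; 83; 0; 1; 0]; [:: 56; 4; 1; 1; 54; 5; 1; 1]; [:: 83; 4; 1; 1; 7; 5; 1; 1];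
     [:: 83; 4; 1; 1; 60; 5; 1; 1]; [:: 83; 4; 1; 1; 17; 5; 1; 1]; [:: 10; 0; 3; 0; 7; 0; 3; 0];
     [:: 10; 2; 3; 2; 17; 2; 3; 2]; [:: 10; 2; 3; 2; 63; 2; 3; 2]; [:: 10; 0; 3; 0; 23; 0; 3; 0];
     [:: 10; 2; 3; 2; 7; 2; 3; 2]; [:: 10; 2; 3; 2; 60; 2; 3; 2]; [:: 10; 0; 14; 0; 7; 0; 7; 0];
     [:: 10; 2; 127; 2; 92; 2; 92; 2]; [:: 10; 0; 127; 0; 92; 0; 92; 0]; [:: 10; 2; 21; 2; 60; 2; 21; 2];
     [:: 43; 0; 9; 0; 7; 0; 7; 0]; [:: 84; 4; 37; 5; 54; 5; 37; 5]; [:: 84; 4; 9; 5; 17; 5; 9; 5];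
     [:: 84; 4; 9; 5; 84; 5; 9; 5]; [:: 84; 4; 37; 5; 54; 5; 37; 5]; [:: 84; 4; 9; 5; 17; 5; 9; 5];
     [:: 43; 0; 9; 0; 43; 0; 9; 0]; [:: 56; 4; 37; 5; 54; 5; 37; 5]; [:: 84; 4; 9; 5; 7; 5; 7; 5];
     [:: 84; 4; 9; 5; 60; 5; 9; 5]; [:: 84; 4; 37; 5; 54; 5; 37; 5]; [:: 84; 4; 9; 5; 17; 5; 9; 5];
     [:: 10; 0; 3; 0; 7; 0; 3; 0]; [:: 10; 2; 3; 2; 17; 2; 3; 2]; [:: 10; 2; 3; 2; 63; 2; 3; 2];
     [:: 10; 2; 3; 2; 17; 2; 3; 2]; [:: 10; 0; 3; 0; 26; 0; 3; 0]; [:: 10; 2; 3; 2; 7; 2; 3; 2];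
     [:: 10; 2; 3; 2; 60; 2; 3; 2]; [:: 10; 2; 3; 2; 17; 2; 3; 2]; [:: 89; 82; 14; 14; 7; 7; 7; 7];
     [:: 89; 82; 14; 14; 7; 7; 7; 7]; [:: 89; 82; 28; 134; 39; 125; 63; 125]; [:: 89; 82; 28; 188; 39; 125; 125; 125];
     [:: 89; 82; 14; 14; 7; 7; 7; 7]; [:: 89; 82; 23; 158; 39; 121; 23; 121]; [:: 10; 4; 14; 5; 7; 5; 7; 5];
     [:: 28; 4; 1; 1; 7; 5; 1; 1]; [:: 28; 4; 1; 1; 38; 5; 1; 1]; [:: 29; 4; 1; 1; 17; 5; 1; 1];
     [:: 28; 4; 1; 1; 38; 5; 1; 1]; [:: 29; 4; 1; 1; 17; 5; 1; 1]; [:: 28; 4; 1; 1; 38; 5; 1; 1];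
     [:: 29; 4; 1; 1; 7; 5; 1; 1]; [:: 28; 4; 1; 1; 38; 5; 1; 1]; [:: 29; 4; 1; 1; 17; 5; 1; 1];
     [:: 10; 4; 3; 5; 7; 5; 3; 5]; [:: 10; 4; 3; 5; 17; 5; 3; 5]; [:: 10; 4; 3; 5; 64; 5; 3; 5];
     [:: 10; 4; 3; 5; 23; 5; 3; 5]; [:: 10; 4; 3; 5; 60; 5; 3; 5]; [:: 10; 4; 14; 5; 7; 5; 7; 5];
     [:: 10; 4; 28; 5; 51; 5; 63; 5]; [:: 10; 4; 28; 5; 51; 5; 187; 5]; [:: 28; 4; 9; 5; 7; 5; 7; 5];
     [:: 28; 4; 28; 5; 51; 5; 37; 5]; [:: 29; 4; 9; 5; 17; 5; 9; 5]; [:: 28; 4; 9; 5; 51; 5; 9; 5];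
     [:: 28; 4; 28; 5; 51; 5; 37; 5]; [:: 29; 4; 9; 5; 17; 5; 9; 5]; [:: 28; 4; 9; 5; 43; 5; 9; 5];
     [:: 28; 4; 28; 5; 51; 5; 37; 5]; [:: 29; 4; 9; 5; 7; 5; 7; 5]; [:: 28; 4; 9; 5; 51; 5; 9; 5];
     [:: 29; 4; 9; 5; 17; 5; 9; 5]; [:: 10; 4; 3; 5; 7; 5; 3; 5]; [:: 10; 4; 3; 5; 17; 5; 3; 5];
     [:: 10; 4; 3; 5; 64; 5; 3; 5]; [:: 10; 4; 3; 5; 17; 5; 3; 5]; [:: 10; 4; 3; 5; 118; 5; 3; 5];
     [:: 10; 4; 3; 5; 7; 5; 3; 5]; [:: 10; 4; 3; 5; 60; 5; 3; 5]; [:: 10; 4; 14; 5; 7; 5; 7; 5];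
     [:: 10; 4; 23; 5; 43; 5; 23; 5]; [:: 28; 4; 1; 1; 7; 5; 1; 1]; [:: 28; 4; 1; 1; 51; 5; 1; 1];
     [:: 29; 4; 1; 1; 17; 5; 1; 1]; [:: 28; 4; 1; 1; 51; 5; 1; 1]; [:: 29; 4; 1; 1; 17; 5; 1; 1];
     [:: 28; 4; 1; 1; 51; 5; 1; 1]; [:: 28; 4; 1; 1; 51; 5; 1; 1]; [:: 29; 4; 1; 1; 7; 5; 1; 1];
     [:: 28; 4; 1; 1; 51; 5; 1; 1]; [:: 29; 4; 1; 1; 17; 5; 1; 1]; [:: 10; 4; 3; 5; 7; 5; 3; 5];
     [:: 10; 4; 3; 5; 17; 5; 3; 5]; [:: 10; 4; 3; 5; 63; 5; 3; 5]; [:: 10; 4; 3; 5; 23; 5; 3; 5];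
     [:: 10; 4; 3; 5; 7; 5; 3; 5]; [:: 10; 4; 3; 5; 60; 5; 3; 5]; [:: 10; 4; 14; 5; 7; 5; 7; 5];
     [:: 10; 4; 28; 5; 51; 5; 92; 5]; [:: 10; 4; 28; 5; 51; 5; 92; 5]; [:: 10; 4; 21; 5; 51; 5; 21; 5];
     [:: 10; 4; 3; 5; 7; 5; 3; 5]; [:: 10; 4; 3; 5; 17; 5; 3; 5]; [:: 10; 4; 3; 5; 63; 5; 3; 5];
     [:: 10; 4; 3; 5; 17; 5; 3; 5]; [:: 10; 4; 3; 5; 118; 5; 3; 5]; [:: 10; 4; 3; 5; 7; 5; 3; 5];
     [:: 10; 4; 3; 5; 60; 5; 3; 5]; [:: 10; 4; 3; 5; 17; 5; 3; 5]; [:: 26; 0; 14; 0; 7; 0; 7; 0];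
     [:: 23; 0; 3; 0; 7; 0; 3; 0]; [:: 34; 2; 3; 2; 17; 2; 3; 2]; [:: 34; 2; 3; 2; 39; 2; 3; 2];
     [:: 23; 0; 3; 0; 23; 0; 3; 0]; [:: 34; 2; 3; 2; 39; 2; 3; 2]; [:: 34; 0; 14; 0; 7; 0; 7; 0];
     [:: 34; 2; 65; 2; 39; 2; 63; 2]; [:: 34; 0; 65; 0; 39; 0; 182; 0]; [:: 26; 0; 3; 0; 7; 0; 3; 0];
     [:: 34; 2; 3; 2; 17; 2; 3; 2]; [:: 34; 2; 3; 2; 39; 2; 3; 2]; [:: 34; 2; 3; 2; 17; 2; 3; 2];
     [:: 26; 0; 3; 0; 26; 0; 3; 0]; [:: 34; 2; 3; 2; 7; 2; 3; 2]; [:: 34; 2; 3; 2; 39; 2; 3; 2];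
     [:: 26; 0; 14; 0; 7; 0; 7; 0]; [:: 26; 0; 23; 0; 26; 0; 23; 0]; [:: 23; 0; 3; 0; 7; 0; 3; 0];
     [:: 34; 2; 3; 2; 17; 2; 3; 2]; [:: 34; 2; 3; 2; 39; 2; 3; 2]; [:: 23; 0; 3; 0; 23; 0; 3; 0];
     [:: 34; 2; 3; 2; 7; 2; 3; 2]; [:: 34; 2; 3; 2; 39; 2; 3; 2]; [:: 34; 0; 14; 0; 7; 0; 7; 0];
     [:: 34; 2; 65; 2; 39; 2; 92; 2]; [:: 34; 0; 65; 0; 39; 0; 92; 0]; [:: 34; 2; 21; 2; 39; 2; 21; 2];
     [:: 10; 0; 14; 0; 7; 0; 7; 0]; [:: 25; 0; 1; 0; 7; 0; 1; 0]; [:: 38; 4; 1; 1; 38; 5; 1; 1];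
     [:: 29; 4; 1; 1; 17; 5; 1; 1]; [:: 38; 4; 1; 1; 38; 5; 1; 1]; [:: 29; 4; 1; 1; 17; 5; 1; 1];
     [:: 25; 0; 1; 0; 25; 0; 1; 0]; [:: 29; 4; 1; 1; 7; 5; 1; 1]; [:: 38; 4; 1; 1; 38; 5; 1; 1];
     [:: 29; 4; 1; 1; 17; 5; 1; 1]; [:: 10; 0; 3; 0; 7; 0; 3; 0]; [:: 10; 2; 3; 2; 17; 2; 3; 2];
     [:: 10; 2; 3; 2; 64; 2; 3; 2]; [:: 10; 0; 3; 0; 23; 0; 3; 0]; [:: 10; 2; 3; 2; 60; 2; 3; 2];
     [:: 25; 0; 9; 0; 7; 0; 7; 0]; [:: 72; 4; 70; 5; 54; 5; 70; 5]; [:: 29; 4; 9; 5; 17; 5; 9; 5];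
     [:: 29; 4; 70; 5; 17; 5; 70; 5]; [:: 77; 4; 9; 5; 64; 5; 9; 5]; [:: 72; 4; 70; 5; 54; 5; 70; 5];
     [:: 29; 4; 9; 5; 17; 5; 9; 5]; [:: 25; 0; 9; 0; 25; 0; 9; 0]; [:: 56; 4; 56; 5; 54; 5; 56; 5];
     [:: 29; 4; 9; 5; 7; 5; 7; 5]; [:: 135; 4; 9; 5; 60; 5; 9; 5]; [:: 72; 4; 71; 5; 54; 5; 119; 5];
     [:: 29; 4; 9; 5; 17; 5; 9; 5]; [:: 10; 0; 14; 0; 7; 0; 7; 0]; [:: 10; 2; 88; 2; 63; 2; 63; 2];
     [:: 10; 0; 159; 0; 25; 0; 162; 0]; [:: 25; 0; 9; 0; 7; 0; 7; 0]; [:: 77; 4; 37; 5; 54; 5; 37; 5];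
     [:: 29; 4; 9; 5; 17; 5; 9; 5]; [:: 77; 4; 9; 5; 64; 5; 9; 5]; [:: 77; 4; 37; 5; 54; 5; 37; 5];
     [:: 29; 4; 9; 5; 17; 5; 9; 5]; [:: 25; 0; 9; 0; 25; 0; 9; 0]; [:: 56; 4; 37; 5; 54; 5; 37; 5];
     [:: 29; 4; 9; 5; 7; 5; 7; 5]; [:: 135; 4; 9; 5; 60; 5; 9; 5]; [:: 29; 4; 9; 5; 17; 5; 9; 5];
     [:: 10; 0; 3; 0; 7; 0; 3; 0]; [:: 10; 2; 3; 2; 17; 2; 3; 2]; [:: 10; 2; 3; 2; 64; 2; 3; 2];
     [:: 10; 2; 3; 2; 17; 2; 3; 2]; [:: 10; 0; 3; 0; 25; 0; 3; 0]; [:: 10; 2; 3; 2; 7; 2; 3; 2];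
     [:: 10; 2; 3; 2; 60; 2; 3; 2]; [:: 25; 0; 9; 0; 7; 0; 7; 0]; [:: 72; 4; 70; 5; 54; 5; 70; 5];
     [:: 29; 4; 9; 5; 17; 5; 9; 5]; [:: 29; 4; 70; 5; 17; 5; 70; 5]; [:: 77; 4; 9; 5; 64; 5; 9; 5];
     [:: 72; 4; 70; 5; 54; 5; 70; 5]; [:: 29; 4; 9; 5; 17; 5; 9; 5]; [:: 29; 4; 70; 5; 17; 5; 70; 5];
     [:: 25; 0; 9; 0; 25; 0; 9; 0]; [:: 56; 4; 56; 5; 54; 5; 56; 5]; [:: 29; 4; 9; 5; 7; 5; 7; 5];
     [:: 29; 4; 71; 5; 17; 5; 122; 5]; [:: 135; 4; 9; 5; 60; 5; 9; 5]; [:: 72; 4; 71; 5; 54; 5; 148; 5];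
     [:: 29; 4; 9; 5; 17; 5; 9; 5]; [:: 10; 0; 14; 0; 7; 0; 7; 0]; [:: 10; 0; 23; 0; 25; 0; 23; 0];
     [:: 25; 0; 1; 0; 7; 0; 1; 0]; [:: 83; 4; 1; 1; 54; 5; 1; 1]; [:: 29; 4; 1; 1; 17; 5; 1; 1];
     [:: 83; 4; 1; 1; 83; 5; 1; 1]; [:: 29; 4; 1; 1; 17; 5; 1; 1]; [:: 25; 0; 1; 0; 25; 0; 1; 0];
     [:: 56; 4; 1; 1; 54; 5; 1; 1]; [:: 29; 4; 1; 1; 7; 5; 1; 1]; [:: 83; 4; 1; 1; 60; 5; 1; 1];
     [:: 29; 4; 1; 1; 17; 5; 1; 1]; [:: 10; 0; 3; 0; 7; 0; 3; 0]; [:: 10; 2; 3; 2; 17; 2; 3; 2];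
     [:: 10; 2; 3; 2; 63; 2; 3; 2]; [:: 10; 0; 3; 0; 23; 0; 3; 0]; [:: 10; 2; 3; 2; 7; 2; 3; 2];
     [:: 10; 2; 3; 2; 60; 2; 3; 2]; [:: 25; 0; 9; 0; 7; 0; 7; 0]; [:: 72; 4; 71; 5; 54; 5; 74; 5];
     [:: 29; 4; 9; 5; 17; 5; 9; 5]; [:: 29; 4; 71; 5; 17; 5; 74; 5]; [:: 74; 4; 9; 5; 74; 5; 9; 5];
     [:: 72; 4; 71; 5; 54; 5; 74; 5]; [:: 29; 4; 9; 5; 17; 5; 9; 5]; [:: 25; 0; 9; 0; 25; 0; 9; 0];
     [:: 56; 4; 56; 5; 54; 5; 56; 5]; [:: 29; 4; 9; 5; 7; 5; 7; 5]; [:: 29; 4; 71; 5; 17; 5; 74; 5];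
     [:: 74; 4; 9; 5; 60; 5; 9; 5]; [:: 72; 4; 71; 5; 54; 5; 74; 5]; [:: 29; 4; 9; 5; 17; 5; 9; 5];
     [:: 10; 0; 14; 0; 7; 0; 7; 0]; [:: 10; 2; 127; 2; 92; 2; 92; 2]; [:: 10; 0; 127; 0; 25; 0; 92; 0];
     [:: 10; 2; 21; 2; 60; 2; 21; 2]; [:: 25; 0; 9; 0; 7; 0; 7; 0]; [:: 84; 4; 37; 5; 54; 5; 37; 5];
     [:: 29; 4; 9; 5; 17; 5; 9; 5]; [:: 84; 4; 9; 5; 84; 5; 9; 5]; [:: 84; 4; 37; 5; 54; 5; 37; 5];
     [:: 29; 4; 9; 5; 17; 5; 9; 5]; [:: 25; 0; 9; 0; 25; 0; 9; 0]; [:: 56; 4; 37; 5; 54; 5; 37; 5];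
     [:: 29; 4; 9; 5; 7; 5; 7; 5]; [:: 84; 4; 9; 5; 60; 5; 9; 5]; [:: 84; 4; 37; 5; 54; 5; 37; 5];
     [:: 29; 4; 9; 5; 17; 5; 9; 5]; [:: 10; 0; 3; 0; 7; 0; 3; 0]; [:: 10; 2; 3; 2; 17; 2; 3; 2];
     [:: 10; 2; 3; 2; 63; 2; 3; 2]; [:: 10; 2; 3; 2; 17; 2; 3; 2]; [:: 10; 0; 3; 0; 25; 0; 3; 0];
     [:: 10; 2; 3; 2; 7; 2; 3; 2]; [:: 10; 2; 3; 2; 60; 2; 3; 2]; [:: 10; 2; 3; 2; 17; 2; 3; 2];
     [:: 121; 82; 14; 14; 7; 7; 7; 7]; [:: 145; 82; 14; 14; 7; 7; 7; 7]; [:: 145; 82; 23; 158; 39; 118; 23; 121];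
     [:: 10; 4; 14; 5; 7; 5; 7; 5]; [:: 25; 4; 1; 1; 7; 5; 1; 1]; [:: 28; 4; 1; 1; 38; 5; 1; 1];
     [:: 38; 4; 1; 1; 17; 5; 1; 1]; [:: 28; 4; 1; 1; 38; 5; 1; 1]; [:: 38; 4; 1; 1; 17; 5; 1; 1];
     [:: 25; 4; 1; 1; 25; 5; 1; 1]; [:: 38; 4; 1; 1; 7; 5; 1; 1]; [:: 28; 4; 1; 1; 38; 5; 1; 1];
     [:: 38; 4; 1; 1; 17; 5; 1; 1]; [:: 10; 4; 3; 5; 7; 5; 3; 5]; [:: 10; 4; 3; 5; 17; 5; 3; 5];
     [:: 10; 4; 3; 5; 133; 5; 3; 5]; [:: 10; 4; 3; 5; 23; 5; 3; 5]; [:: 10; 4; 3; 5; 60; 5; 3; 5];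
     [:: 10; 4; 14; 5; 7; 5; 7; 5]; [:: 10; 4; 28; 5; 51; 5; 63; 5]; [:: 10; 4; 28; 5; 25; 5; 175; 5];
     [:: 10; 4; 3; 5; 7; 5; 3; 5]; [:: 10; 4; 3; 5; 17; 5; 3; 5]; [:: 10; 4; 3; 5; 133; 5; 3; 5];
     [:: 10; 4; 3; 5; 17; 5; 3; 5]; [:: 10; 4; 3; 5; 25; 5; 3; 5]; [:: 10; 4; 3; 5; 7; 5; 3; 5];
     [:: 10; 4; 3; 5; 60; 5; 3; 5]; [:: 10; 4; 14; 5; 7; 5; 7; 5]; [:: 10; 4; 23; 5; 25; 5; 23; 5];
     [:: 25; 4; 1; 1; 7; 5; 1; 1]; [:: 28; 4; 1; 1; 51; 5; 1; 1]; [:: 115; 4; 1; 1; 17; 5; 1; 1];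
     [:: 28; 4; 1; 1; 51; 5; 1; 1]; [:: 115; 4; 1; 1; 17; 5; 1; 1]; [:: 25; 4; 1; 1; 25; 5; 1; 1];
     [:: 28; 4; 1; 1; 51; 5; 1; 1]; [:: 115; 4; 1; 1; 7; 5; 1; 1]; [:: 28; 4; 1; 1; 51; 5; 1; 1];
     [:: 115; 4; 1; 1; 17; 5; 1; 1]; [:: 10; 4; 3; 5; 7; 5; 3; 5]; [:: 10; 4; 3; 5; 17; 5; 3; 5];
     [:: 10; 4; 3; 5; 63; 5; 3; 5]; [:: 10; 4; 3; 5; 23; 5; 3; 5]; [:: 10; 4; 3; 5; 7; 5; 3; 5];
     [:: 10; 4; 3; 5; 60; 5; 3; 5]; [:: 10; 4; 14; 5; 7; 5; 7; 5]; [:: 10; 4; 28; 5; 51; 5; 92; 5];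
     [:: 10; 4; 28; 5; 25; 5; 92; 5]; [:: 10; 4; 21; 5; 51; 5; 21; 5]; [:: 10; 4; 3; 5; 7; 5; 3; 5];
     [:: 10; 4; 3; 5; 17; 5; 3; 5]; [:: 10; 4; 3; 5; 63; 5; 3; 5]; [:: 10; 4; 3; 5; 17; 5; 3; 5];
     [:: 10; 4; 3; 5; 25; 5; 3; 5]; [:: 10; 4; 3; 5; 7; 5; 3; 5]; [:: 10; 4; 3; 5; 60; 5; 3; 5];
     [:: 10; 4; 3; 5; 17; 5; 3; 5]; [:: 26; 0; 14; 0; 7; 0; 7; 0]; [:: 23; 0; 3; 0; 7; 0; 3; 0];
     [:: 34; 2; 3; 2; 17; 2; 3; 2]; [:: 34; 2; 3; 2; 39; 2; 3; 2]; [:: 23; 0; 3; 0; 23; 0; 3; 0];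
     [:: 34; 2; 3; 2; 39; 2; 3; 2]; [:: 34; 0; 14; 0; 7; 0; 7; 0]; [:: 34; 2; 65; 2; 39; 2; 63; 2];
     [:: 34; 0; 65; 0; 39; 0; 125; 0]; [:: 26; 0; 14; 0; 7; 0; 7; 0]; [:: 26; 0; 23; 0; 26; 0; 23; 0];
     [:: 23; 0; 3; 0; 7; 0; 3; 0]; [:: 34; 2; 3; 2; 17; 2; 3; 2]; [:: 34; 2; 3; 2; 39; 2; 3; 2];
     [:: 23; 0; 3; 0; 23; 0; 3; 0]; [:: 34; 2; 3; 2; 7; 2; 3; 2]; [:: 34; 2; 3; 2; 39; 2; 3; 2];
     [:: 34; 0; 14; 0; 7; 0; 7; 0]; [:: 34; 2; 65; 2; 39; 2; 92; 2]; [:: 34; 0; 65; 0; 39; 0; 92; 0];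
     [:: 34; 2; 21; 2; 39; 2; 21; 2]; [:: 10; 0; 14; 0; 7; 0; 7; 0]; [:: 38; 0; 1; 0; 7; 0; 1; 0];
     [:: 38; 4; 1; 1; 38; 5; 1; 1]; [:: 38; 4; 1; 1; 17; 5; 1; 1]; [:: 38; 4; 1; 1; 38; 5; 1; 1];
     [:: 38; 4; 1; 1; 17; 5; 1; 1]; [:: 38; 0; 1; 0; 38; 0; 1; 0]; [:: 38; 4; 1; 1; 7; 5; 1; 1];
     [:: 38; 4; 1; 1; 38; 5; 1; 1]; [:: 38; 4; 1; 1; 17; 5; 1; 1]; [:: 10; 0; 3; 0; 7; 0; 3; 0];
     [:: 10; 2; 3; 2; 17; 2; 3; 2]; [:: 10; 2; 3; 2; 80; 2; 3; 2]; [:: 10; 0; 3; 0; 23; 0; 3; 0];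
     [:: 10; 2; 3; 2; 60; 2; 3; 2]; [:: 56; 0; 9; 0; 7; 0; 7; 0]; [:: 80; 4; 70; 5; 54; 5; 70; 5];
     [:: 80; 4; 9; 5; 17; 5; 9; 5]; [:: 80; 4; 70; 5; 17; 5; 70; 5]; [:: 80; 4; 9; 5; 80; 5; 9; 5];
     [:: 80; 4; 70; 5; 54; 5; 70; 5]; [:: 80; 4; 9; 5; 17; 5; 9; 5]; [:: 80; 0; 9; 0; 80; 0; 9; 0];
     [:: 56; 4; 56; 5; 54; 5; 56; 5]; [:: 80; 4; 9; 5; 7; 5; 7; 5]; [:: 80; 4; 9; 5; 60; 5; 9; 5];
     [:: 80; 4; 71; 5; 54; 5; 80; 5]; [:: 80; 4; 9; 5; 17; 5; 9; 5]; [:: 10; 0; 14; 0; 7; 0; 7; 0];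
     [:: 10; 2; 80; 2; 63; 2; 63; 2]; [:: 10; 0; 80; 0; 80; 0; 80; 0]; [:: 43; 0; 9; 0; 7; 0; 7; 0];
     [:: 80; 4; 37; 5; 54; 5; 37; 5]; [:: 80; 4; 9; 5; 17; 5; 9; 5]; [:: 80; 4; 9; 5; 80; 5; 9; 5];
     [:: 80; 4; 37; 5; 54; 5; 37; 5]; [:: 80; 4; 9; 5; 17; 5; 9; 5]; [:: 43; 0; 9; 0; 43; 0; 9; 0];
     [:: 56; 4; 37; 5; 54; 5; 37; 5]; [:: 80; 4; 9; 5; 7; 5; 7; 5]; [:: 80; 4; 9; 5; 60; 5; 9; 5];
     [:: 80; 4; 9; 5; 17; 5; 9; 5]; [:: 10; 0; 3; 0; 7; 0; 3; 0]; [:: 10; 2; 3; 2; 17; 2; 3; 2];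
     [:: 10; 2; 3; 2; 80; 2; 3; 2]; [:: 10; 2; 3; 2; 17; 2; 3; 2]; [:: 10; 0; 3; 0; 26; 0; 3; 0];
     [:: 10; 2; 3; 2; 7; 2; 3; 2]; [:: 10; 2; 3; 2; 60; 2; 3; 2]; [:: 10; 0; 14; 0; 7; 0; 7; 0];
     [:: 10; 0; 23; 0; 26; 0; 23; 0]; [:: 56; 0; 1; 0; 7; 0; 1; 0]; [:: 80; 4; 1; 1; 54; 5; 1; 1];
     [:: 80; 4; 1; 1; 17; 5; 1; 1]; [:: 80; 4; 1; 1; 80; 5; 1; 1]; [:: 80; 4; 1; 1; 17; 5; 1; 1];
     [:: 80; 0; 1; 0; 80; 0; 1; 0]; [:: 56; 4; 1; 1; 54; 5; 1; 1]; [:: 80; 4; 1; 1; 7; 5; 1; 1];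
     [:: 80; 4; 1; 1; 60; 5; 1; 1]; [:: 80; 4; 1; 1; 17; 5; 1; 1]; [:: 10; 0; 3; 0; 7; 0; 3; 0];
     [:: 10; 2; 3; 2; 17; 2; 3; 2]; [:: 10; 2; 3; 2; 63; 2; 3; 2]; [:: 10; 0; 3; 0; 23; 0; 3; 0];
     [:: 10; 2; 3; 2; 7; 2; 3; 2]; [:: 10; 2; 3; 2; 60; 2; 3; 2]; [:: 56; 0; 9; 0; 7; 0; 7; 0];
     [:: 74; 4; 71; 5; 54; 5; 74; 5]; [:: 74; 4; 9; 5; 17; 5; 9; 5]; [:: 74; 4; 71; 5; 17; 5; 74; 5];
     [:: 74; 4; 9; 5; 74; 5; 9; 5]; [:: 74; 4; 71; 5; 54; 5; 74; 5]; [:: 74; 4; 9; 5; 17; 5; 9; 5];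
     [:: 74; 0; 9; 0; 74; 0; 9; 0]; [:: 56; 4; 56; 5; 54; 5; 56; 5]; [:: 74; 4; 9; 5; 7; 5; 7; 5];
     [:: 74; 4; 71; 5; 17; 5; 74; 5]; [:: 74; 4; 9; 5; 60; 5; 9; 5]; [:: 74; 4; 71; 5; 54; 5; 74; 5];
     [:: 74; 4; 9; 5; 17; 5; 9; 5]; [:: 10; 0; 14; 0; 7; 0; 7; 0]; [:: 10; 2; 80; 2; 80; 2; 80; 2];
     [:: 10; 0; 80; 0; 80; 0; 80; 0]; [:: 10; 2; 21; 2; 60; 2; 21; 2]; [:: 43; 0; 9; 0; 7; 0; 7; 0];
     [:: 80; 4; 37; 5; 54; 5; 37; 5]; [:: 80; 4; 9; 5; 17; 5; 9; 5]; [:: 80; 4; 9; 5; 80; 5; 9; 5];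
     [:: 80; 4; 37; 5; 54; 5; 37; 5]; [:: 80; 4; 9; 5; 17; 5; 9; 5]; [:: 43; 0; 9; 0; 43; 0; 9; 0];
     [:: 56; 4; 37; 5; 54; 5; 37; 5]; [:: 80; 4; 9; 5; 7; 5; 7; 5]; [:: 80; 4; 9; 5; 60; 5; 9; 5];
     [:: 80; 4; 37; 5; 54; 5; 37; 5]; [:: 80; 4; 9; 5; 17; 5; 9; 5]; [:: 10; 0; 3; 0; 7; 0; 3; 0];
     [:: 10; 2; 3; 2; 17; 2; 3; 2]; [:: 10; 2; 3; 2; 63; 2; 3; 2]; [:: 10; 2; 3; 2; 17; 2; 3; 2];
     [:: 10; 0; 3; 0; 26; 0; 3; 0]; [:: 10; 2; 3; 2; 7; 2; 3; 2]; [:: 10; 2; 3; 2; 60; 2; 3; 2];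
     [:: 10; 2; 3; 2; 17; 2; 3; 2]; [:: 89; 82; 14; 14; 7; 7; 7; 7]; [:: 89; 82; 14; 14; 7; 7; 7; 7];
     [:: 89; 82; 28; 147; 39; 173; 63; 147]; [:: 89; 82; 28; 170; 39; 173; 162; 170]; [:: 89; 82; 14; 14; 7; 7; 7; 7];
     [:: 89; 82; 23; 158; 39; 121; 23; 121]; [:: 89; 82; 14; 14; 7; 7; 7; 7]; [:: 89; 82; 28; 127; 39; 92; 92; 92];
     [:: 89; 82; 28; 127; 39; 92; 92; 92]; [:: 89; 82; 21; 21; 39; 60; 21; 21]; [:: 10; 4; 14; 5; 7; 5; 7; 5];
     [:: 28; 4; 1; 1; 7; 5; 1; 1]; [:: 28; 4; 1; 1; 38; 5; 1; 1]; [:: 29; 4; 1; 1; 17; 5; 1; 1];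
     [:: 28; 4; 1; 1; 38; 5; 1; 1]; [:: 29; 4; 1; 1; 17; 5; 1; 1]; [:: 28; 4; 1; 1; 38; 5; 1; 1];
     [:: 29; 4; 1; 1; 7; 5; 1; 1]; [:: 28; 4; 1; 1; 38; 5; 1; 1]; [:: 29; 4; 1; 1; 17; 5; 1; 1];
     [:: 10; 4; 3; 5; 7; 5; 3; 5]; [:: 10; 4; 3; 5; 17; 5; 3; 5]; [:: 10; 4; 3; 5; 133; 5; 3; 5];
     [:: 10; 4; 3; 5; 23; 5; 3; 5]; [:: 10; 4; 3; 5; 60; 5; 3; 5]; [:: 10; 4; 14; 5; 7; 5; 7; 5];
     [:: 10; 4; 28; 5; 51; 5; 63; 5]; [:: 10; 4; 28; 5; 51; 5; 181; 5]; [:: 28; 4; 9; 5; 7; 5; 7; 5];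
     [:: 28; 4; 28; 5; 51; 5; 37; 5]; [:: 29; 4; 9; 5; 17; 5; 9; 5]; [:: 28; 4; 9; 5; 51; 5; 9; 5];
     [:: 28; 4; 28; 5; 51; 5; 37; 5]; [:: 29; 4; 9; 5; 17; 5; 9; 5]; [:: 28; 4; 9; 5; 43; 5; 9; 5];
     [:: 28; 4; 28; 5; 51; 5; 37; 5]; [:: 29; 4; 9; 5; 7; 5; 7; 5]; [:: 28; 4; 9; 5; 51; 5; 9; 5];
     [:: 29; 4; 9; 5; 17; 5; 9; 5]; [:: 10; 4; 3; 5; 7; 5; 3; 5]; [:: 10; 4; 3; 5; 17; 5; 3; 5];
     [:: 10; 4; 3; 5; 133; 5; 3; 5]; [:: 10; 4; 3; 5; 17; 5; 3; 5]; [:: 10; 4; 3; 5; 118; 5; 3; 5];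
     [:: 10; 4; 3; 5; 7; 5; 3; 5]; [:: 10; 4; 3; 5; 60; 5; 3; 5]; [:: 10; 4; 14; 5; 7; 5; 7; 5];
     [:: 10; 4; 23; 5; 43; 5; 23; 5]; [:: 28; 4; 1; 1; 7; 5; 1; 1]; [:: 28; 4; 1; 1; 51; 5; 1; 1];
     [:: 29; 4; 1; 1; 17; 5; 1; 1]; [:: 28; 4; 1; 1; 51; 5; 1; 1]; [:: 29; 4; 1; 1; 17; 5; 1; 1];
     [:: 28; 4; 1; 1; 51; 5; 1; 1]; [:: 28; 4; 1; 1; 51; 5; 1; 1]; [:: 29; 4; 1; 1; 7; 5; 1; 1];
     [:: 28; 4; 1; 1; 51; 5; 1; 1]; [:: 29; 4; 1; 1; 17; 5; 1; 1]; [:: 10; 4; 3; 5; 7; 5; 3; 5];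
     [:: 10; 4; 3; 5; 17; 5; 3; 5]; [:: 10; 4; 3; 5; 63; 5; 3; 5]; [:: 10; 4; 3; 5; 23; 5; 3; 5];
     [:: 10; 4; 3; 5; 7; 5; 3; 5]; [:: 10; 4; 3; 5; 60; 5; 3; 5]; [:: 10; 4; 14; 5; 7; 5; 7; 5];
     [:: 10; 4; 28; 5; 51; 5; 92; 5]; [:: 10; 4; 28; 5; 51; 5; 92; 5]; [:: 10; 4; 21; 5; 51; 5; 21; 5];
     [:: 28; 4; 9; 5; 7; 5; 7; 5]; [:: 28; 4; 28; 5; 51; 5; 37; 5]; [:: 29; 4; 9; 5; 17; 5; 9; 5];
     [:: 28; 4; 9; 5; 51; 5; 9; 5]; [:: 28; 4; 28; 5; 51; 5; 37; 5]; [:: 29; 4; 9; 5; 17; 5; 9; 5];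
     [:: 28; 4; 9; 5; 43; 5; 9; 5]; [:: 28; 4; 28; 5; 51; 5; 37; 5]; [:: 29; 4; 9; 5; 7; 5; 7; 5];
     [:: 28; 4; 9; 5; 51; 5; 9; 5]; [:: 28; 4; 28; 5; 51; 5; 37; 5]; [:: 29; 4; 9; 5; 17; 5; 9; 5];
     [:: 10; 4; 3; 5; 7; 5; 3; 5]; [:: 10; 4; 3; 5; 17; 5; 3; 5]; [:: 10; 4; 3; 5; 63; 5; 3; 5];
     [:: 10; 4; 3; 5; 17; 5; 3; 5]; [:: 10; 4; 3; 5; 118; 5; 3; 5]; [:: 10; 4; 3; 5; 7; 5; 3; 5];
     [:: 10; 4; 3; 5; 60; 5; 3; 5]; [:: 10; 4; 3; 5; 17; 5; 3; 5]; [:: 26; 0; 14; 0; 7; 0; 7; 0];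
     [:: 23; 0; 3; 0; 7; 0; 3; 0]; [:: 34; 2; 3; 2; 17; 2; 3; 2]; [:: 34; 2; 3; 2; 39; 2; 3; 2];
     [:: 23; 0; 3; 0; 23; 0; 3; 0]; [:: 34; 2; 3; 2; 39; 2; 3; 2]; [:: 34; 0; 14; 0; 7; 0; 7; 0];
     [:: 34; 2; 65; 2; 39; 2; 63; 2]; [:: 34; 0; 65; 0; 39; 0; 125; 0]; [:: 26; 0; 3; 0; 7; 0; 3; 0];
     [:: 34; 2; 3; 2; 17; 2; 3; 2]; [:: 34; 2; 3; 2; 39; 2; 3; 2]; [:: 34; 2; 3; 2; 17; 2; 3; 2];
     [:: 26; 0; 3; 0; 26; 0; 3; 0]; [:: 34; 2; 3; 2; 7; 2; 3; 2]; [:: 34; 2; 3; 2; 39; 2; 3; 2];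
     [:: 26; 0; 14; 0; 7; 0; 7; 0]; [:: 26; 0; 23; 0; 26; 0; 23; 0]; [:: 23; 0; 3; 0; 7; 0; 3; 0];
     [:: 34; 2; 3; 2; 17; 2; 3; 2]; [:: 34; 2; 3; 2; 39; 2; 3; 2]; [:: 23; 0; 3; 0; 23; 0; 3; 0];
     [:: 34; 2; 3; 2; 7; 2; 3; 2]; [:: 34; 2; 3; 2; 39; 2; 3; 2]; [:: 34; 0; 14; 0; 7; 0; 7; 0];
     [:: 34; 2; 65; 2; 39; 2; 92; 2]; [:: 34; 0; 65; 0; 39; 0; 92; 0]; [:: 34; 2; 21; 2; 39; 2; 21; 2];
     [:: 26; 0; 3; 0; 7; 0; 3; 0]; [:: 34; 2; 3; 2; 17; 2; 3; 2]; [:: 34; 2; 3; 2; 39; 2; 3; 2];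
     [:: 34; 2; 3; 2; 17; 2; 3; 2]; [:: 26; 0; 3; 0; 26; 0; 3; 0]; [:: 34; 2; 3; 2; 7; 2; 3; 2];
     [:: 34; 2; 3; 2; 39; 2; 3; 2]; [:: 34; 2; 3; 2; 17; 2; 3; 2]; [:: 10; 0; 14; 0; 7; 0; 7; 0];
     [:: 25; 0; 1; 0; 7; 0; 1; 0]; [:: 38; 4; 1; 1; 38; 5; 1; 1]; [:: 29; 4; 1; 1; 17; 5; 1; 1];
     [:: 38; 4; 1; 1; 38; 5; 1; 1]; [:: 29; 4; 1; 1; 17; 5; 1; 1]; [:: 25; 0; 1; 0; 25; 0; 1; 0];
     [:: 29; 4; 1; 1; 7; 5; 1; 1]; [:: 38; 4; 1; 1; 38; 5; 1; 1]; [:: 29; 4; 1; 1; 17; 5; 1; 1];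
     [:: 10; 0; 3; 0; 7; 0; 3; 0]; [:: 10; 2; 3; 2; 17; 2; 3; 2]; [:: 10; 2; 3; 2; 133; 2; 3; 2];
     [:: 10; 0; 3; 0; 23; 0; 3; 0]; [:: 10; 2; 3; 2; 60; 2; 3; 2]; [:: 25; 0; 9; 0; 7; 0; 7; 0];
     [:: 72; 4; 70; 5; 54; 5; 70; 5]; [:: 29; 4; 9; 5; 17; 5; 9; 5]; [:: 29; 4; 70; 5; 17; 5; 70; 5];
     [:: 167; 4; 9; 5; 169; 5; 9; 5]; [:: 72; 4; 70; 5; 54; 5; 70; 5]; [:: 29; 4; 9; 5; 17; 5; 9; 5];
     [:: 25; 0; 9; 0; 25; 0; 9; 0]; [:: 56; 4; 56; 5; 54; 5; 56; 5]; [:: 29; 4; 9; 5; 7; 5; 7; 5];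
     [:: 135; 4; 9; 5; 60; 5; 9; 5]; [:: 72; 4; 71; 5; 54; 5; 119; 5]; [:: 29; 4; 9; 5; 17; 5; 9; 5];
     [:: 10; 0; 14; 0; 7; 0; 7; 0]; [:: 10; 2; 88; 2; 63; 2; 63; 2]; [:: 10; 0; 159; 0; 25; 0; 162; 0];
     [:: 25; 0; 9; 0; 7; 0; 7; 0]; [:: 97; 4; 37; 5; 54; 5; 37; 5]; [:: 29; 4; 9; 5; 17; 5; 9; 5];
     [:: 165; 4; 9; 5; 165; 5; 9; 5]; [:: 185; 4; 37; 5; 54; 5; 37; 5]; [:: 29; 4; 9; 5; 17; 5; 9; 5];
     [:: 25; 0; 9; 0; 25; 0; 9; 0]; [:: 56; 4; 37; 5; 54; 5; 37; 5]; [:: 29; 4; 9; 5; 7; 5; 7; 5];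
     [:: 135; 4; 9; 5; 60; 5; 9; 5]; [:: 29; 4; 9; 5; 17; 5; 9; 5]; [:: 10; 0; 3; 0; 7; 0; 3; 0];
     [:: 10; 2; 3; 2; 17; 2; 3; 2]; [:: 10; 2; 3; 2; 133; 2; 3; 2]; [:: 10; 2; 3; 2; 17; 2; 3; 2];
     [:: 10; 0; 3; 0; 25; 0; 3; 0]; [:: 10; 2; 3; 2; 7; 2; 3; 2]; [:: 10; 2; 3; 2; 60; 2; 3; 2];
     [:: 25; 0; 9; 0; 7; 0; 7; 0]; [:: 72; 4; 70; 5; 54; 5; 70; 5]; [:: 29; 4; 9; 5; 17; 5; 9; 5];
     [:: 29; 4; 70; 5; 17; 5; 70; 5]; [:: 167; 4; 9; 5; 169; 5; 9; 5]; [:: 72; 4; 70; 5; 54; 5; 70; 5];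
     [:: 29; 4; 9; 5; 17; 5; 9; 5]; [:: 29; 4; 70; 5; 17; 5; 70; 5]; [:: 25; 0; 9; 0; 25; 0; 9; 0];
     [:: 56; 4; 56; 5; 54; 5; 56; 5]; [:: 29; 4; 9; 5; 7; 5; 7; 5]; [:: 29; 4; 71; 5; 17; 5; 122; 5];
     [:: 135; 4; 9; 5; 60; 5; 9; 5]; [:: 72; 4; 71; 5; 54; 5; 148; 5]; [:: 29; 4; 9; 5; 17; 5; 9; 5];
     [:: 10; 0; 14; 0; 7; 0; 7; 0]; [:: 10; 0; 23; 0; 25; 0; 23; 0]; [:: 25; 0; 1; 0; 7; 0; 1; 0];
     [:: 83; 4; 1; 1; 54; 5; 1; 1]; [:: 29; 4; 1; 1; 17; 5; 1; 1]; [:: 83; 4; 1; 1; 83; 5; 1; 1];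
     [:: 29; 4; 1; 1; 17; 5; 1; 1]; [:: 25; 0; 1; 0; 25; 0; 1; 0]; [:: 56; 4; 1; 1; 54; 5; 1; 1];
     [:: 29; 4; 1; 1; 7; 5; 1; 1]; [:: 83; 4; 1; 1; 60; 5; 1; 1]; [:: 29; 4; 1; 1; 17; 5; 1; 1];
     [:: 10; 0; 3; 0; 7; 0; 3; 0]; [:: 10; 2; 3; 2; 17; 2; 3; 2]; [:: 10; 2; 3; 2; 63; 2; 3; 2];
     [:: 10; 0; 3; 0; 23; 0; 3; 0]; [:: 10; 2; 3; 2; 7; 2; 3; 2]; [:: 10; 2; 3; 2; 60; 2; 3; 2];
     [:: 25; 0; 9; 0; 7; 0; 7; 0]; [:: 72; 4; 71; 5; 54; 5; 74; 5]; [:: 29; 4; 9; 5; 17; 5; 9; 5];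
     [:: 29; 4; 71; 5; 17; 5; 74; 5]; [:: 74; 4; 9; 5; 74; 5; 9; 5]; [:: 72; 4; 71; 5; 54; 5; 74; 5];
     [:: 29; 4; 9; 5; 17; 5; 9; 5]; [:: 25; 0; 9; 0; 25; 0; 9; 0]; [:: 56; 4; 56; 5; 54; 5; 56; 5];
     [:: 29; 4; 9; 5; 7; 5; 7; 5]; [:: 29; 4; 71; 5; 17; 5; 74; 5]; [:: 74; 4; 9; 5; 60; 5; 9; 5];
     [:: 72; 4; 71; 5; 54; 5; 74; 5]; [:: 29; 4; 9; 5; 17; 5; 9; 5]; [:: 10; 0; 14; 0; 7; 0; 7; 0];
     [:: 10; 2; 127; 2; 92; 2; 92; 2]; [:: 10; 0; 127; 0; 25; 0; 92; 0]; [:: 10; 2; 21; 2; 60; 2; 21; 2];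
     [:: 25; 0; 9; 0; 7; 0; 7; 0]; [:: 84; 4; 37; 5; 54; 5; 37; 5]; [:: 29; 4; 9; 5; 17; 5; 9; 5];
     [:: 84; 4; 9; 5; 84; 5; 9; 5]; [:: 84; 4; 37; 5; 54; 5; 37; 5]; [:: 29; 4; 9; 5; 17; 5; 9; 5];
     [:: 25; 0; 9; 0; 25; 0; 9; 0]; [:: 56; 4; 37; 5; 54; 5; 37; 5]; [:: 29; 4; 9; 5; 7; 5; 7; 5];
     [:: 84; 4; 9; 5; 60; 5; 9; 5]; [:: 84; 4; 37; 5; 54; 5; 37; 5]; [:: 29; 4; 9; 5; 17; 5; 9; 5];
     [:: 10; 0; 3; 0; 7; 0; 3; 0]; [:: 10; 2; 3; 2; 17; 2; 3; 2]; [:: 10; 2; 3; 2; 63; 2; 3; 2];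
     [:: 10; 2; 3; 2; 17; 2; 3; 2]; [:: 10; 0; 3; 0; 25; 0; 3; 0]; [:: 10; 2; 3; 2; 7; 2; 3; 2];
     [:: 10; 2; 3; 2; 60; 2; 3; 2]; [:: 10; 2; 3; 2; 17; 2; 3; 2]; [:: 25; 0; 9; 0; 7; 0; 7; 0];
     [:: 72; 4; 71; 5; 54; 5; 122; 5]; [:: 29; 4; 9; 5; 17; 5; 9; 5]; [:: 29; 4; 71; 5; 17; 5; 154; 5];
     [:: 166; 4; 9; 5; 166; 5; 9; 5]; [:: 72; 4; 71; 5; 54; 5; 154; 5]; [:: 29; 4; 9; 5; 17; 5; 9; 5];
     [:: 29; 4; 71; 5; 17; 5; 154; 5]; [:: 25; 0; 9; 0; 25; 0; 9; 0]; [:: 56; 4; 56; 5; 54; 5; 56; 5];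
     [:: 29; 4; 9; 5; 7; 5; 7; 5]; [:: 29; 4; 71; 5; 17; 5; 122; 5]; [:: 135; 4; 9; 5; 60; 5; 9; 5];
     [:: 72; 4; 71; 5; 54; 5; 148; 5]; [:: 29; 4; 9; 5; 17; 5; 9; 5]; [:: 29; 4; 71; 5; 17; 5; 154; 5]];
  [:: [:: 23; 0; 1; 0; 23; 0; 1; 0]; [:: 10; 0; 1; 0; 18; 0; 1; 0]; [:: 1; 0; 1; 0; 1; 0; 1; 0];
     [:: 1; 1; 1; 1; 1; 1; 1; 1]; [:: 1; 1; 1; 1; 1; 1; 1; 1]; [:: 1; 1; 1; 1; 1; 1; 1; 1];
     [:: 1; 1; 1; 1; 1; 1; 1; 1]; [:: 1; 0; 1; 0; 1; 0; 1; 0]; [:: 1; 1; 1; 1; 1; 1; 1; 1];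
     [:: 1; 1; 1; 1; 1; 1; 1; 1]; [:: 1; 1; 1; 1; 1; 1; 1; 1]; [:: 10; 0; 3; 0; 18; 0; 3; 0];
     [:: 10; 4; 3; 18; 17; 13; 3; 18]; [:: 10; 4; 3; 18; 18; 13; 3; 18]; [:: 10; 0; 3; 0; 18; 0; 3; 0];
     [:: 10; 4; 3; 18; 18; 13; 3; 18]; [:: 10; 0; 18; 0; 18; 0; 18; 0]; [:: 10; 4; 18; 8; 18; 8; 18; 8];
     [:: 10; 0; 18; 0; 18; 0; 18; 0]; [:: 10; 0; 3; 0; 18; 0; 3; 0]; [:: 10; 4; 3; 18; 17; 13; 3; 18];
     [:: 10; 4; 3; 18; 18; 13; 3; 18]; [:: 10; 4; 3; 18; 17; 13; 3; 18]; [:: 10; 0; 3; 0; 18; 0; 3; 0];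
     [:: 10; 4; 3; 18; 17; 13; 3; 18]; [:: 10; 4; 3; 18; 18; 13; 3; 18]; [:: 10; 0; 1; 0; 18; 0; 1; 0];
     [:: 10; 0; 1; 0; 18; 0; 1; 0]; [:: 10; 0; 3; 0; 18; 0; 3; 0]; [:: 10; 4; 3; 18; 17; 13; 3; 18];
     [:: 10; 4; 3; 18; 18; 13; 3; 18]; [:: 10; 0; 3; 0; 18; 0; 3; 0]; [:: 10; 4; 3; 18; 17; 13; 3; 18];
     [:: 10; 4; 3; 18; 18; 13; 3; 18]; [:: 10; 0; 18; 0; 18; 0; 18; 0]; [:: 10; 4; 18; 8; 18; 8; 18; 8];
     [:: 10; 0; 18; 0; 18; 0; 18; 0]; [:: 10; 4; 18; 8; 18; 8; 18; 8]; [:: 10; 0; 3; 0; 18; 0; 3; 0];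
     [:: 10; 4; 3; 18; 17; 13; 3; 18]; [:: 10; 4; 3; 18; 18; 13; 3; 18]; [:: 10; 4; 3; 18; 17; 13; 3; 18];
     [:: 10; 0; 3; 0; 18; 0; 3; 0]; [:: 10; 4; 3; 18; 17; 13; 3; 18]; [:: 10; 4; 3; 18; 18; 13; 3; 18];
     [:: 10; 4; 3; 18; 17; 13; 3; 18]; [:: 0; 0; 0; 0; 0; 0; 0; 0]; [:: 0; 0; 0; 0; 0; 0; 0; 0];
     [:: 34; 2; 3; 2; 17; 2; 3; 2]; [:: 34; 2; 3; 2; 39; 2; 3; 2]; [:: 0; 0; 0; 0; 0; 0; 0; 0];
     [:: 34; 2; 3; 2; 39; 2; 3; 2]; [:: 0; 0; 0; 0; 0; 0; 0; 0]; [:: 34; 2; 55; 2; 39; 2; 55; 2];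
     [:: 0; 0; 0; 0; 0; 0; 0; 0]; [:: 0; 0; 0; 0; 0; 0; 0; 0]; [:: 0; 0; 0; 0; 0; 0; 0; 0];
     [:: 0; 0; 0; 0; 0; 0; 0; 0]; [:: 34; 2; 55; 2; 39; 2; 55; 2]; [:: 0; 0; 0; 0; 0; 0; 0; 0];
     [:: 34; 2; 55; 2; 39; 2; 55; 2]; [:: 0; 0; 0; 0; 0; 0; 0; 0]; [:: 0; 0; 0; 0; 0; 0; 0; 0];
     [:: 1; 1; 1; 1; 1; 1; 1; 1]; [:: 1; 1; 1; 1; 1; 1; 1; 1]; [:: 1; 1; 1; 1; 1; 1; 1; 1];
     [:: 1; 1; 1; 1; 1; 1; 1; 1]; [:: 0; 0; 0; 0; 0; 0; 0; 0]; [:: 1; 1; 1; 1; 1; 1; 1; 1];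
     [:: 1; 1; 1; 1; 1; 1; 1; 1]; [:: 1; 1; 1; 1; 1; 1; 1; 1]; [:: 0; 0; 0; 0; 0; 0; 0; 0];
     [:: 10; 2; 3; 2; 17; 2; 3; 2]; [:: 10; 2; 3; 2; 64; 2; 3; 2]; [:: 0; 0; 0; 0; 0; 0; 0; 0];
     [:: 10; 2; 3; 2; 102; 2; 3; 2]; [:: 0; 0; 0; 0; 0; 0; 0; 0]; [:: 73; 4; 70; 19; 54; 19; 70; 19];
     [:: 73; 4; 9; 19; 17; 13; 9; 19]; [:: 73; 4; 70; 19; 17; 19; 70; 19]; [:: 73; 4; 9; 19; 64; 13; 9; 19];
     [:: 73; 4; 70; 19; 54; 19; 70; 19]; [:: 73; 4; 9; 19; 17; 13; 9; 19]; [:: 0; 0; 0; 0; 0; 0; 0; 0];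
     [:: 73; 4; 71; 40; 54; 40; 100; 40]; [:: 73; 4; 9; 40; 17; 13; 9; 40]; [:: 73; 4; 9; 40; 114; 13; 9; 40];
     [:: 73; 4; 71; 40; 54; 40; 100; 40]; [:: 73; 4; 9; 40; 17; 13; 9; 40]; [:: 0; 0; 0; 0; 0; 0; 0; 0];
     [:: 10; 2; 55; 2; 55; 2; 55; 2]; [:: 0; 0; 0; 0; 0; 0; 0; 0]; [:: 0; 0; 0; 0; 0; 0; 0; 0];
     [:: 73; 4; 37; 8; 54; 8; 37; 8]; [:: 73; 4; 9; 19; 17; 13; 9; 19]; [:: 62; 4; 9; 8; 62; 8; 9; 8];
     [:: 73; 4; 37; 8; 54; 8; 37; 8]; [:: 73; 4; 9; 19; 17; 13; 9; 19]; [:: 0; 0; 0; 0; 0; 0; 0; 0];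
     [:: 73; 4; 37; 8; 54; 8; 37; 8]; [:: 73; 4; 9; 40; 17; 13; 9; 40]; [:: 62; 4; 9; 8; 62; 8; 9; 8];
     [:: 73; 4; 9; 40; 17; 13; 9; 40]; [:: 0; 0; 0; 0; 0; 0; 0; 0]; [:: 10; 2; 3; 2; 17; 2; 3; 2];
     [:: 10; 2; 3; 2; 64; 2; 3; 2]; [:: 10; 2; 3; 2; 17; 2; 3; 2]; [:: 0; 0; 0; 0; 0; 0; 0; 0];
     [:: 10; 2; 3; 2; 17; 2; 3; 2]; [:: 10; 2; 3; 2; 102; 2; 3; 2]; [:: 0; 0; 0; 0; 0; 0; 0; 0];
     [:: 0; 0; 0; 0; 0; 0; 0; 0]; [:: 0; 0; 0; 0; 0; 0; 0; 0]; [:: 1; 1; 1; 1; 1; 1; 1; 1];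
     [:: 1; 1; 1; 1; 1; 1; 1; 1]; [:: 1; 1; 1; 1; 1; 1; 1; 1]; [:: 1; 1; 1; 1; 1; 1; 1; 1];
     [:: 0; 0; 0; 0; 0; 0; 0; 0]; [:: 1; 1; 1; 1; 1; 1; 1; 1]; [:: 1; 1; 1; 1; 1; 1; 1; 1];
     [:: 1; 1; 1; 1; 1; 1; 1; 1]; [:: 1; 1; 1; 1; 1; 1; 1; 1]; [:: 0; 0; 0; 0; 0; 0; 0; 0];
     [:: 10; 2; 3; 2; 17; 2; 3; 2]; [:: 10; 2; 3; 2; 102; 2; 3; 2]; [:: 0; 0; 0; 0; 0; 0; 0; 0];
     [:: 10; 2; 3; 2; 17; 2; 3; 2]; [:: 10; 2; 3; 2; 102; 2; 3; 2]; [:: 0; 0; 0; 0; 0; 0; 0; 0];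
     [:: 10; 2; 55; 2; 55; 2; 55; 2]; [:: 0; 0; 0; 0; 0; 0; 0; 0]; [:: 10; 2; 55; 2; 55; 2; 55; 2];
     [:: 0; 0; 0; 0; 0; 0; 0; 0]; [:: 73; 4; 37; 8; 54; 8; 37; 8]; [:: 73; 4; 9; 40; 17; 13; 9; 40];
     [:: 62; 4; 9; 8; 62; 8; 9; 8]; [:: 73; 4; 37; 8; 54; 8; 37; 8]; [:: 73; 4; 9; 40; 17; 13; 9; 40];
     [:: 0; 0; 0; 0; 0; 0; 0; 0]; [:: 73; 4; 37; 8; 54; 8; 37; 8]; [:: 73; 4; 9; 40; 17; 13; 9; 40];
     [:: 62; 4; 9; 8; 62; 8; 9; 8]; [:: 73; 4; 37; 8; 54; 8; 37; 8]; [:: 73; 4; 9; 40; 17; 13; 9; 40];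
     [:: 0; 0; 0; 0; 0; 0; 0; 0]; [:: 10; 2; 3; 2; 17; 2; 3; 2]; [:: 10; 2; 3; 2; 102; 2; 3; 2];
     [:: 10; 2; 3; 2; 17; 2; 3; 2]; [:: 0; 0; 0; 0; 0; 0; 0; 0]; [:: 10; 2; 3; 2; 17; 2; 3; 2];
     [:: 10; 2; 3; 2; 102; 2; 3; 2]; [:: 10; 2; 3; 2; 17; 2; 3; 2]; [:: 23; 0; 1; 0; 23; 0; 1; 0];
     [:: 102; 0; 28; 0; 39; 0; 62; 0]; [:: 102; 55; 28; 55; 39; 55; 62; 55]; [:: 102; 0; 28; 0; 39; 0; 62; 0];
     [:: 23; 0; 1; 0; 23; 0; 1; 0]; [:: 23; 0; 1; 0; 23; 0; 1; 0]; [:: 10; 0; 1; 0; 23; 0; 1; 0];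
     [:: 1; 0; 1; 0; 1; 0; 1; 0]; [:: 1; 1; 1; 1; 1; 1; 1; 1]; [:: 1; 1; 1; 1; 1; 1; 1; 1];
     [:: 1; 1; 1; 1; 1; 1; 1; 1]; [:: 1; 1; 1; 1; 1; 1; 1; 1]; [:: 1; 0; 1; 0; 1; 0; 1; 0];
     [:: 1; 1; 1; 1; 1; 1; 1; 1]; [:: 1; 1; 1; 1; 1; 1; 1; 1]; [:: 1; 1; 1; 1; 1; 1; 1; 1];
     [:: 10; 0; 3; 0; 23; 0; 3; 0]; [:: 10; 4; 3; 19; 17; 13; 3; 19]; [:: 10; 4; 3; 19; 64; 13; 3; 19];
     [:: 10; 0; 3; 0; 23; 0; 3; 0]; [:: 10; 4; 3; 40; 90; 13; 3; 40]; [:: 10; 0; 28; 0; 51; 0; 62; 0];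
     [:: 10; 4; 28; 8; 51; 8; 62; 8]; [:: 10; 0; 28; 0; 51; 0; 62; 0]; [:: 28; 0; 9; 0; 51; 0; 9; 0];
     [:: 28; 4; 28; 8; 51; 8; 37; 8]; [:: 29; 4; 9; 19; 17; 13; 9; 19]; [:: 28; 4; 9; 8; 51; 8; 9; 8];
     [:: 28; 4; 28; 8; 51; 8; 37; 8]; [:: 29; 4; 9; 19; 17; 13; 9; 19]; [:: 28; 0; 9; 0; 51; 0; 9; 0];
     [:: 28; 4; 28; 8; 51; 8; 37; 8]; [:: 29; 4; 9; 40; 17; 13; 9; 40]; [:: 28; 4; 9; 8; 51; 8; 9; 8];
     [:: 29; 4; 9; 40; 17; 13; 9; 40]; [:: 10; 0; 3; 0; 64; 0; 3; 0]; [:: 10; 4; 3; 19; 17; 13; 3; 19];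
     [:: 10; 4; 3; 19; 64; 13; 3; 19]; [:: 10; 4; 3; 19; 17; 13; 3; 19]; [:: 10; 0; 3; 0; 90; 0; 3; 0];
     [:: 10; 4; 3; 40; 17; 13; 3; 40]; [:: 10; 4; 3; 40; 90; 13; 3; 40]; [:: 10; 0; 1; 0; 23; 0; 1; 0];
     [:: 10; 0; 1; 0; 23; 0; 1; 0]; [:: 1; 0; 1; 0; 1; 0; 1; 0]; [:: 1; 1; 1; 1; 1; 1; 1; 1];
     [:: 1; 1; 1; 1; 1; 1; 1; 1]; [:: 1; 1; 1; 1; 1; 1; 1; 1]; [:: 1; 1; 1; 1; 1; 1; 1; 1];
     [:: 1; 0; 1; 0; 1; 0; 1; 0]; [:: 1; 1; 1; 1; 1; 1; 1; 1]; [:: 1; 1; 1; 1; 1; 1; 1; 1];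
     [:: 1; 1; 1; 1; 1; 1; 1; 1]; [:: 1; 1; 1; 1; 1; 1; 1; 1]; [:: 10; 0; 3; 0; 23; 0; 3; 0];
     [:: 10; 4; 3; 40; 17; 13; 3; 40]; [:: 10; 4; 3; 40; 90; 13; 3; 40]; [:: 10; 0; 3; 0; 23; 0; 3; 0];
     [:: 10; 4; 3; 40; 17; 13; 3; 40]; [:: 10; 4; 3; 40; 90; 13; 3; 40]; [:: 10; 0; 28; 0; 51; 0; 62; 0];
     [:: 10; 4; 28; 8; 51; 8; 62; 8]; [:: 10; 0; 28; 0; 51; 0; 62; 0]; [:: 10; 4; 28; 8; 51; 8; 62; 8];
     [:: 10; 0; 3; 0; 90; 0; 3; 0]; [:: 10; 4; 3; 40; 17; 13; 3; 40]; [:: 10; 4; 3; 40; 90; 13; 3; 40];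
     [:: 10; 4; 3; 40; 17; 13; 3; 40]; [:: 10; 0; 3; 0; 90; 0; 3; 0]; [:: 10; 4; 3; 40; 17; 13; 3; 40];
     [:: 10; 4; 3; 40; 90; 13; 3; 40]; [:: 10; 4; 3; 40; 17; 13; 3; 40]; [:: 0; 0; 0; 0; 0; 0; 0; 0];
     [:: 0; 0; 0; 0; 0; 0; 0; 0]; [:: 34; 2; 3; 2; 17; 2; 3; 2]; [:: 34; 2; 3; 2; 39; 2; 3; 2];
     [:: 0; 0; 0; 0; 0; 0; 0; 0]; [:: 34; 2; 3; 2; 39; 2; 3; 2]; [:: 0; 0; 0; 0; 0; 0; 0; 0];
     [:: 34; 2; 55; 2; 39; 2; 55; 2]; [:: 0; 0; 0; 0; 0; 0; 0; 0]; [:: 0; 0; 0; 0; 0; 0; 0; 0];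
     [:: 34; 2; 3; 2; 17; 2; 3; 2]; [:: 34; 2; 3; 2; 39; 2; 3; 2]; [:: 34; 2; 3; 2; 17; 2; 3; 2];
     [:: 0; 0; 0; 0; 0; 0; 0; 0]; [:: 34; 2; 3; 2; 17; 2; 3; 2]; [:: 34; 2; 3; 2; 39; 2; 3; 2];
     [:: 0; 0; 0; 0; 0; 0; 0; 0]; [:: 0; 0; 0; 0; 0; 0; 0; 0]; [:: 0; 0; 0; 0; 0; 0; 0; 0];
     [:: 34; 2; 3; 2; 17; 2; 3; 2]; [:: 34; 2; 3; 2; 39; 2; 3; 2]; [:: 0; 0; 0; 0; 0; 0; 0; 0];
     [:: 34; 2; 3; 2; 17; 2; 3; 2]; [:: 34; 2; 3; 2; 39; 2; 3; 2]; [:: 0; 0; 0; 0; 0; 0; 0; 0];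
     [:: 34; 2; 55; 2; 39; 2; 55; 2]; [:: 0; 0; 0; 0; 0; 0; 0; 0]; [:: 34; 2; 55; 2; 39; 2; 55; 2];
     [:: 0; 0; 0; 0; 0; 0; 0; 0]; [:: 0; 0; 0; 0; 0; 0; 0; 0]; [:: 1; 1; 1; 1; 1; 1; 1; 1];
     [:: 1; 1; 1; 1; 1; 1; 1; 1]; [:: 1; 1; 1; 1; 1; 1; 1; 1]; [:: 1; 1; 1; 1; 1; 1; 1; 1];
     [:: 0; 0; 0; 0; 0; 0; 0; 0]; [:: 1; 1; 1; 1; 1; 1; 1; 1]; [:: 1; 1; 1; 1; 1; 1; 1; 1];
     [:: 1; 1; 1; 1; 1; 1; 1; 1]; [:: 0; 0; 0; 0; 0; 0; 0; 0]; [:: 10; 2; 3; 2; 17; 2; 3; 2];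
     [:: 10; 2; 3; 2; 64; 2; 3; 2]; [:: 0; 0; 0; 0; 0; 0; 0; 0]; [:: 10; 2; 3; 2; 102; 2; 3; 2];
     [:: 0; 0; 0; 0; 0; 0; 0; 0]; [:: 72; 4; 70; 19; 54; 19; 70; 19]; [:: 29; 4; 9; 19; 17; 13; 9; 19];
     [:: 29; 4; 70; 19; 17; 19; 70; 19]; [:: 73; 4; 9; 19; 64; 13; 9; 19]; [:: 72; 4; 70; 19; 54; 19; 70; 19];
     [:: 29; 4; 9; 19; 17; 13; 9; 19]; [:: 0; 0; 0; 0; 0; 0; 0; 0]; [:: 72; 4; 71; 40; 54; 40; 100; 40];
     [:: 29; 4; 9; 40; 17; 13; 9; 40]; [:: 73; 4; 9; 40; 114; 13; 9; 40]; [:: 72; 4; 71; 40; 54; 40; 100; 40];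
     [:: 29; 4; 9; 40; 17; 13; 9; 40]; [:: 0; 0; 0; 0; 0; 0; 0; 0]; [:: 10; 2; 55; 2; 55; 2; 55; 2];
     [:: 0; 0; 0; 0; 0; 0; 0; 0]; [:: 0; 0; 0; 0; 0; 0; 0; 0]; [:: 73; 4; 37; 8; 54; 8; 37; 8];
     [:: 29; 4; 9; 19; 17; 13; 9; 19]; [:: 62; 4; 9; 8; 62; 8; 9; 8]; [:: 73; 4; 37; 8; 54; 8; 37; 8];
     [:: 29; 4; 9; 19; 17; 13; 9; 19]; [:: 0; 0; 0; 0; 0; 0; 0; 0]; [:: 73; 4; 37; 8; 54; 8; 37; 8];
     [:: 29; 4; 9; 40; 17; 13; 9; 40]; [:: 62; 4; 9; 8; 62; 8; 9; 8]; [:: 29; 4; 9; 40; 17; 13; 9; 40];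
     [:: 0; 0; 0; 0; 0; 0; 0; 0]; [:: 10; 2; 3; 2; 17; 2; 3; 2]; [:: 10; 2; 3; 2; 64; 2; 3; 2];
     [:: 10; 2; 3; 2; 17; 2; 3; 2]; [:: 0; 0; 0; 0; 0; 0; 0; 0]; [:: 10; 2; 3; 2; 17; 2; 3; 2];
     [:: 10; 2; 3; 2; 102; 2; 3; 2]; [:: 0; 0; 0; 0; 0; 0; 0; 0]; [:: 72; 4; 70; 19; 54; 19; 70; 19];
     [:: 29; 4; 9; 19; 17; 13; 9; 19]; [:: 29; 4; 70; 19; 17; 19; 70; 19]; [:: 73; 4; 9; 19; 64; 13; 9; 19];
     [:: 72; 4; 70; 19; 54; 19; 70; 19]; [:: 29; 4; 9; 19; 17; 13; 9; 19]; [:: 29; 4; 70; 19; 17; 19; 70; 19];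
     [:: 0; 0; 0; 0; 0; 0; 0; 0]; [:: 72; 4; 71; 40; 54; 40; 117; 40]; [:: 29; 4; 9; 40; 17; 13; 9; 40];
     [:: 29; 4; 71; 40; 17; 40; 117; 40]; [:: 73; 4; 9; 40; 114; 13; 9; 40]; [:: 72; 4; 71; 40; 54; 40; 117; 40];
     [:: 29; 4; 9; 40; 17; 13; 9; 40]; [:: 0; 0; 0; 0; 0; 0; 0; 0]; [:: 0; 0; 0; 0; 0; 0; 0; 0];
     [:: 0; 0; 0; 0; 0; 0; 0; 0]; [:: 1; 1; 1; 1; 1; 1; 1; 1]; [:: 1; 1; 1; 1; 1; 1; 1; 1];
     [:: 1; 1; 1; 1; 1; 1; 1; 1]; [:: 1; 1; 1; 1; 1; 1; 1; 1]; [:: 0; 0; 0; 0; 0; 0; 0; 0];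
     [:: 1; 1; 1; 1; 1; 1; 1; 1]; [:: 1; 1; 1; 1; 1; 1; 1; 1]; [:: 1; 1; 1; 1; 1; 1; 1; 1];
     [:: 1; 1; 1; 1; 1; 1; 1; 1]; [:: 0; 0; 0; 0; 0; 0; 0; 0]; [:: 10; 2; 3; 2; 17; 2; 3; 2];
     [:: 10; 2; 3; 2; 102; 2; 3; 2]; [:: 0; 0; 0; 0; 0; 0; 0; 0]; [:: 10; 2; 3; 2; 17; 2; 3; 2];
     [:: 10; 2; 3; 2; 102; 2; 3; 2]; [:: 0; 0; 0; 0; 0; 0; 0; 0]; [:: 72; 4; 71; 40; 54; 40; 100; 40];
     [:: 29; 4; 9; 40; 17; 13; 9; 40]; [:: 29; 4; 71; 40; 17; 40; 100; 40]; [:: 73; 4; 9; 40; 114; 13; 9; 40];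
     [:: 72; 4; 71; 40; 54; 40; 100; 40]; [:: 29; 4; 9; 40; 17; 13; 9; 40]; [:: 0; 0; 0; 0; 0; 0; 0; 0];
     [:: 72; 4; 71; 40; 54; 40; 100; 40]; [:: 29; 4; 9; 40; 17; 13; 9; 40]; [:: 29; 4; 71; 40; 17; 40; 100; 40];
     [:: 73; 4; 9; 40; 114; 13; 9; 40]; [:: 72; 4; 71; 40; 54; 40; 100; 40]; [:: 29; 4; 9; 40; 17; 13; 9; 40];
     [:: 0; 0; 0; 0; 0; 0; 0; 0]; [:: 10; 2; 55; 2; 55; 2; 55; 2]; [:: 0; 0; 0; 0; 0; 0; 0; 0];
     [:: 10; 2; 55; 2; 55; 2; 55; 2]; [:: 0; 0; 0; 0; 0; 0; 0; 0]; [:: 73; 4; 37; 8; 54; 8; 37; 8];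
     [:: 29; 4; 9; 40; 17; 13; 9; 40]; [:: 62; 4; 9; 8; 62; 8; 9; 8]; [:: 73; 4; 37; 8; 54; 8; 37; 8];
     [:: 29; 4; 9; 40; 17; 13; 9; 40]; [:: 0; 0; 0; 0; 0; 0; 0; 0]; [:: 73; 4; 37; 8; 54; 8; 37; 8];
     [:: 29; 4; 9; 40; 17; 13; 9; 40]; [:: 62; 4; 9; 8; 62; 8; 9; 8]; [:: 73; 4; 37; 8; 54; 8; 37; 8];
     [:: 29; 4; 9; 40; 17; 13; 9; 40]; [:: 0; 0; 0; 0; 0; 0; 0; 0]; [:: 10; 2; 3; 2; 17; 2; 3; 2];
     [:: 10; 2; 3; 2; 102; 2; 3; 2]; [:: 10; 2; 3; 2; 17; 2; 3; 2]; [:: 0; 0; 0; 0; 0; 0; 0; 0];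
     [:: 10; 2; 3; 2; 17; 2; 3; 2]; [:: 10; 2; 3; 2; 102; 2; 3; 2]; [:: 10; 2; 3; 2; 17; 2; 3; 2];
     [:: 23; 0; 1; 0; 23; 0; 1; 0]; [:: 23; 0; 1; 0; 23; 0; 1; 0]; [:: 23; 0; 1; 0; 23; 0; 1; 0];
     [:: 10; 0; 1; 0; 18; 0; 1; 0]; [:: 1; 0; 1; 0; 1; 0; 1; 0]; [:: 1; 1; 1; 1; 1; 1; 1; 1];
     [:: 1; 1; 1; 1; 1; 1; 1; 1]; [:: 1; 1; 1; 1; 1; 1; 1; 1]; [:: 1; 1; 1; 1; 1; 1; 1; 1];
     [:: 1; 0; 1; 0; 1; 0; 1; 0]; [:: 1; 1; 1; 1; 1; 1; 1; 1]; [:: 1; 1; 1; 1; 1; 1; 1; 1];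
     [:: 1; 1; 1; 1; 1; 1; 1; 1]; [:: 10; 0; 3; 0; 18; 0; 3; 0]; [:: 10; 4; 3; 18; 17; 13; 3; 18];
     [:: 10; 4; 3; 18; 18; 13; 3; 18]; [:: 10; 0; 3; 0; 18; 0; 3; 0]; [:: 10; 4; 3; 18; 18; 13; 3; 18];
     [:: 10; 0; 18; 0; 18; 0; 18; 0]; [:: 10; 4; 18; 8; 18; 8; 18; 8]; [:: 10; 0; 18; 0; 18; 0; 18; 0];
     [:: 10; 0; 3; 0; 18; 0; 3; 0]; [:: 10; 4; 3; 18; 17; 13; 3; 18]; [:: 10; 4; 3; 18; 18; 13; 3; 18];
     [:: 10; 4; 3; 18; 17; 13; 3; 18]; [:: 10; 0; 3; 0; 18; 0; 3; 0]; [:: 10; 4; 3; 18; 17; 13; 3; 18];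
     [:: 10; 4; 3; 18; 18; 13; 3; 18]; [:: 10; 0; 1; 0; 18; 0; 1; 0]; [:: 10; 0; 1; 0; 18; 0; 1; 0];
     [:: 1; 0; 1; 0; 1; 0; 1; 0]; [:: 1; 1; 1; 1; 1; 1; 1; 1]; [:: 1; 1; 1; 1; 1; 1; 1; 1];
     [:: 1; 1; 1; 1; 1; 1; 1; 1]; [:: 1; 1; 1; 1; 1; 1; 1; 1]; [:: 1; 0; 1; 0; 1; 0; 1; 0];
     [:: 1; 1; 1; 1; 1; 1; 1; 1]; [:: 1; 1; 1; 1; 1; 1; 1; 1]; [:: 1; 1; 1; 1; 1; 1; 1; 1];
     [:: 1; 1; 1; 1; 1; 1; 1; 1]; [:: 10; 0; 3; 0; 18; 0; 3; 0]; [:: 10; 4; 3; 18; 17; 13; 3; 18];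
     [:: 10; 4; 3; 18; 18; 13; 3; 18]; [:: 10; 0; 3; 0; 18; 0; 3; 0]; [:: 10; 4; 3; 18; 17; 13; 3; 18];
     [:: 10; 4; 3; 18; 18; 13; 3; 18]; [:: 10; 0; 18; 0; 18; 0; 18; 0]; [:: 10; 4; 18; 8; 18; 8; 18; 8];
     [:: 10; 0; 18; 0; 18; 0; 18; 0]; [:: 10; 4; 18; 8; 18; 8; 18; 8]; [:: 10; 0; 3; 0; 18; 0; 3; 0];
     [:: 10; 4; 3; 18; 17; 13; 3; 18]; [:: 10; 4; 3; 18; 18; 13; 3; 18]; [:: 10; 4; 3; 18; 17; 13; 3; 18];
     [:: 10; 0; 3; 0; 18; 0; 3; 0]; [:: 10; 4; 3; 18; 17; 13; 3; 18]; [:: 10; 4; 3; 18; 18; 13; 3; 18];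
     [:: 10; 4; 3; 18; 17; 13; 3; 18]; [:: 0; 0; 0; 0; 0; 0; 0; 0]; [:: 0; 0; 0; 0; 0; 0; 0; 0];
     [:: 34; 2; 3; 2; 17; 2; 3; 2]; [:: 34; 2; 3; 2; 39; 2; 3; 2]; [:: 0; 0; 0; 0; 0; 0; 0; 0];
     [:: 34; 2; 3; 2; 39; 2; 3; 2]; [:: 0; 0; 0; 0; 0; 0; 0; 0]; [:: 34; 2; 55; 2; 39; 2; 55; 2];
     [:: 0; 0; 0; 0; 0; 0; 0; 0]; [:: 0; 0; 0; 0; 0; 0; 0; 0]; [:: 0; 0; 0; 0; 0; 0; 0; 0];
     [:: 0; 0; 0; 0; 0; 0; 0; 0]; [:: 34; 2; 3; 2; 17; 2; 3; 2]; [:: 34; 2; 3; 2; 39; 2; 3; 2];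
     [:: 0; 0; 0; 0; 0; 0; 0; 0]; [:: 34; 2; 3; 2; 17; 2; 3; 2]; [:: 34; 2; 3; 2; 39; 2; 3; 2];
     [:: 0; 0; 0; 0; 0; 0; 0; 0]; [:: 34; 2; 55; 2; 39; 2; 55; 2]; [:: 0; 0; 0; 0; 0; 0; 0; 0];
     [:: 34; 2; 55; 2; 39; 2; 55; 2]; [:: 0; 0; 0; 0; 0; 0; 0; 0]; [:: 0; 0; 0; 0; 0; 0; 0; 0];
     [:: 1; 1; 1; 1; 1; 1; 1; 1]; [:: 1; 1; 1; 1; 1; 1; 1; 1]; [:: 1; 1; 1; 1; 1; 1; 1; 1];
     [:: 1; 1; 1; 1; 1; 1; 1; 1]; [:: 0; 0; 0; 0; 0; 0; 0; 0]; [:: 1; 1; 1; 1; 1; 1; 1; 1];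
     [:: 1; 1; 1; 1; 1; 1; 1; 1]; [:: 1; 1; 1; 1; 1; 1; 1; 1]; [:: 0; 0; 0; 0; 0; 0; 0; 0];
     [:: 10; 2; 3; 2; 17; 2; 3; 2]; [:: 10; 2; 3; 2; 102; 2; 3; 2]; [:: 0; 0; 0; 0; 0; 0; 0; 0];
     [:: 10; 2; 3; 2; 102; 2; 3; 2]; [:: 0; 0; 0; 0; 0; 0; 0; 0]; [:: 73; 4; 70; 19; 54; 19; 70; 19];
     [:: 73; 4; 9; 19; 17; 13; 9; 19]; [:: 73; 4; 70; 19; 17; 19; 70; 19]; [:: 73; 4; 9; 19; 114; 13; 9; 19];
     [:: 73; 4; 70; 19; 54; 19; 70; 19]; [:: 73; 4; 9; 19; 17; 13; 9; 19]; [:: 0; 0; 0; 0; 0; 0; 0; 0];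
     [:: 73; 4; 71; 40; 54; 40; 100; 40]; [:: 73; 4; 9; 40; 17; 13; 9; 40]; [:: 73; 4; 9; 40; 114; 13; 9; 40];
     [:: 73; 4; 71; 40; 54; 40; 100; 40]; [:: 73; 4; 9; 40; 17; 13; 9; 40]; [:: 0; 0; 0; 0; 0; 0; 0; 0];
     [:: 10; 2; 55; 2; 55; 2; 55; 2]; [:: 0; 0; 0; 0; 0; 0; 0; 0]; [:: 0; 0; 0; 0; 0; 0; 0; 0];
     [:: 73; 4; 37; 8; 54; 8; 37; 8]; [:: 73; 4; 9; 19; 17; 13; 9; 19]; [:: 62; 4; 9; 8; 62; 8; 9; 8];
     [:: 73; 4; 37; 8; 54; 8; 37; 8]; [:: 73; 4; 9; 19; 17; 13; 9; 19]; [:: 0; 0; 0; 0; 0; 0; 0; 0];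
     [:: 73; 4; 37; 8; 54; 8; 37; 8]; [:: 73; 4; 9; 40; 17; 13; 9; 40]; [:: 62; 4; 9; 8; 62; 8; 9; 8];
     [:: 73; 4; 9; 40; 17; 13; 9; 40]; [:: 0; 0; 0; 0; 0; 0; 0; 0]; [:: 10; 2; 3; 2; 17; 2; 3; 2];
     [:: 10; 2; 3; 2; 102; 2; 3; 2]; [:: 10; 2; 3; 2; 17; 2; 3; 2]; [:: 0; 0; 0; 0; 0; 0; 0; 0];
     [:: 10; 2; 3; 2; 17; 2; 3; 2]; [:: 10; 2; 3; 2; 102; 2; 3; 2]; [:: 0; 0; 0; 0; 0; 0; 0; 0];
     [:: 0; 0; 0; 0; 0; 0; 0; 0]; [:: 0; 0; 0; 0; 0; 0; 0; 0]; [:: 1; 1; 1; 1; 1; 1; 1; 1];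
     [:: 1; 1; 1; 1; 1; 1; 1; 1]; [:: 1; 1; 1; 1; 1; 1; 1; 1]; [:: 1; 1; 1; 1; 1; 1; 1; 1];
     [:: 0; 0; 0; 0; 0; 0; 0; 0]; [:: 1; 1; 1; 1; 1; 1; 1; 1]; [:: 1; 1; 1; 1; 1; 1; 1; 1];
     [:: 1; 1; 1; 1; 1; 1; 1; 1]; [:: 1; 1; 1; 1; 1; 1; 1; 1]; [:: 0; 0; 0; 0; 0; 0; 0; 0];
     [:: 10; 2; 3; 2; 17; 2; 3; 2]; [:: 10; 2; 3; 2; 102; 2; 3; 2]; [:: 0; 0; 0; 0; 0; 0; 0; 0];
     [:: 10; 2; 3; 2; 17; 2; 3; 2]; [:: 10; 2; 3; 2; 102; 2; 3; 2]; [:: 0; 0; 0; 0; 0; 0; 0; 0];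
     [:: 73; 4; 71; 40; 54; 40; 100; 40]; [:: 73; 4; 9; 40; 17; 13; 9; 40]; [:: 73; 4; 71; 40; 17; 40; 100; 40];
     [:: 73; 4; 9; 40; 114; 13; 9; 40]; [:: 73; 4; 71; 40; 54; 40; 100; 40]; [:: 73; 4; 9; 40; 17; 13; 9; 40];
     [:: 0; 0; 0; 0; 0; 0; 0; 0]; [:: 73; 4; 71; 40; 54; 40; 100; 40]; [:: 73; 4; 9; 40; 17; 13; 9; 40];
     [:: 73; 4; 71; 40; 17; 40; 100; 40]; [:: 73; 4; 9; 40; 114; 13; 9; 40]; [:: 73; 4; 71; 40; 54; 40; 100; 40];
     [:: 73; 4; 9; 40; 17; 13; 9; 40]; [:: 0; 0; 0; 0; 0; 0; 0; 0]; [:: 10; 2; 55; 2; 55; 2; 55; 2];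
     [:: 0; 0; 0; 0; 0; 0; 0; 0]; [:: 10; 2; 55; 2; 55; 2; 55; 2]; [:: 0; 0; 0; 0; 0; 0; 0; 0];
     [:: 73; 4; 37; 8; 54; 8; 37; 8]; [:: 73; 4; 9; 40; 17; 13; 9; 40]; [:: 62; 4; 9; 8; 62; 8; 9; 8];
     [:: 73; 4; 37; 8; 54; 8; 37; 8]; [:: 73; 4; 9; 40; 17; 13; 9; 40]; [:: 0; 0; 0; 0; 0; 0; 0; 0];
     [:: 73; 4; 37; 8; 54; 8; 37; 8]; [:: 73; 4; 9; 40; 17; 13; 9; 40]; [:: 62; 4; 9; 8; 62; 8; 9; 8];
     [:: 73; 4; 37; 8; 54; 8; 37; 8]; [:: 73; 4; 9; 40; 17; 13; 9; 40]; [:: 0; 0; 0; 0; 0; 0; 0; 0];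
     [:: 10; 2; 3; 2; 17; 2; 3; 2]; [:: 10; 2; 3; 2; 102; 2; 3; 2]; [:: 10; 2; 3; 2; 17; 2; 3; 2];
     [:: 0; 0; 0; 0; 0; 0; 0; 0]; [:: 10; 2; 3; 2; 17; 2; 3; 2]; [:: 10; 2; 3; 2; 102; 2; 3; 2];
     [:: 10; 2; 3; 2; 17; 2; 3; 2]; [:: 23; 0; 1; 0; 23; 0; 1; 0]; [:: 102; 0; 28; 0; 39; 0; 62; 0];
     [:: 102; 55; 28; 55; 39; 55; 62; 55]; [:: 102; 0; 28; 0; 39; 0; 62; 0]; [:: 23; 0; 1; 0; 23; 0; 1; 0];
     [:: 23; 0; 1; 0; 23; 0; 1; 0]; [:: 102; 0; 28; 0; 39; 0; 62; 0]; [:: 102; 55; 28; 55; 39; 55; 62; 55];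
     [:: 102; 0; 28; 0; 39; 0; 62; 0]; [:: 102; 55; 28; 55; 39; 55; 62; 55]; [:: 10; 0; 1; 0; 23; 0; 1; 0];
     [:: 1; 0; 1; 0; 1; 0; 1; 0]; [:: 1; 1; 1; 1; 1; 1; 1; 1]; [:: 1; 1; 1; 1; 1; 1; 1; 1];
     [:: 1; 1; 1; 1; 1; 1; 1; 1]; [:: 1; 1; 1; 1; 1; 1; 1; 1]; [:: 1; 0; 1; 0; 1; 0; 1; 0];
     [:: 1; 1; 1; 1; 1; 1; 1; 1]; [:: 1; 1; 1; 1; 1; 1; 1; 1]; [:: 1; 1; 1; 1; 1; 1; 1; 1];
     [:: 10; 0; 3; 0; 23; 0; 3; 0]; [:: 10; 4; 3; 19; 17; 13; 3; 19]; [:: 10; 4; 3; 19; 90; 13; 3; 19];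
     [:: 10; 0; 3; 0; 23; 0; 3; 0]; [:: 10; 4; 3; 40; 90; 13; 3; 40]; [:: 10; 0; 28; 0; 51; 0; 62; 0];
     [:: 10; 4; 28; 8; 51; 8; 62; 8]; [:: 10; 0; 28; 0; 51; 0; 62; 0]; [:: 28; 0; 9; 0; 51; 0; 9; 0];
     [:: 28; 4; 28; 8; 51; 8; 37; 8]; [:: 29; 4; 9; 19; 17; 13; 9; 19]; [:: 28; 4; 9; 8; 51; 8; 9; 8];
     [:: 28; 4; 28; 8; 51; 8; 37; 8]; [:: 29; 4; 9; 19; 17; 13; 9; 19]; [:: 28; 0; 9; 0; 51; 0; 9; 0];
     [:: 28; 4; 28; 8; 51; 8; 37; 8]; [:: 29; 4; 9; 40; 17; 13; 9; 40]; [:: 28; 4; 9; 8; 51; 8; 9; 8];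
     [:: 29; 4; 9; 40; 17; 13; 9; 40]; [:: 10; 0; 3; 0; 90; 0; 3; 0]; [:: 10; 4; 3; 19; 17; 13; 3; 19];
     [:: 10; 4; 3; 19; 90; 13; 3; 19]; [:: 10; 4; 3; 19; 17; 13; 3; 19]; [:: 10; 0; 3; 0; 90; 0; 3; 0];
     [:: 10; 4; 3; 40; 17; 13; 3; 40]; [:: 10; 4; 3; 40; 90; 13; 3; 40]; [:: 10; 0; 1; 0; 23; 0; 1; 0];
     [:: 10; 0; 1; 0; 23; 0; 1; 0]; [:: 1; 0; 1; 0; 1; 0; 1; 0]; [:: 1; 1; 1; 1; 1; 1; 1; 1];
     [:: 1; 1; 1; 1; 1; 1; 1; 1]; [:: 1; 1; 1; 1; 1; 1; 1; 1]; [:: 1; 1; 1; 1; 1; 1; 1; 1];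
     [:: 1; 0; 1; 0; 1; 0; 1; 0]; [:: 1; 1; 1; 1; 1; 1; 1; 1]; [:: 1; 1; 1; 1; 1; 1; 1; 1];
     [:: 1; 1; 1; 1; 1; 1; 1; 1]; [:: 1; 1; 1; 1; 1; 1; 1; 1]; [:: 10; 0; 3; 0; 23; 0; 3; 0];
     [:: 10; 4; 3; 40; 17; 13; 3; 40]; [:: 10; 4; 3; 40; 90; 13; 3; 40]; [:: 10; 0; 3; 0; 23; 0; 3; 0];
     [:: 10; 4; 3; 40; 17; 13; 3; 40]; [:: 10; 4; 3; 40; 90; 13; 3; 40]; [:: 10; 0; 28; 0; 51; 0; 62; 0];
     [:: 10; 4; 28; 8; 51; 8; 62; 8]; [:: 10; 0; 28; 0; 51; 0; 62; 0]; [:: 10; 4; 28; 8; 51; 8; 62; 8];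
     [:: 28; 0; 9; 0; 51; 0; 9; 0]; [:: 28; 4; 28; 8; 51; 8; 37; 8]; [:: 29; 4; 9; 40; 17; 13; 9; 40];
     [:: 28; 4; 9; 8; 51; 8; 9; 8]; [:: 28; 4; 28; 8; 51; 8; 37; 8]; [:: 29; 4; 9; 40; 17; 13; 9; 40];
     [:: 28; 0; 9; 0; 51; 0; 9; 0]; [:: 28; 4; 28; 8; 51; 8; 37; 8]; [:: 29; 4; 9; 40; 17; 13; 9; 40];
     [:: 28; 4; 9; 8; 51; 8; 9; 8]; [:: 28; 4; 28; 8; 51; 8; 37; 8]; [:: 29; 4; 9; 40; 17; 13; 9; 40];
     [:: 10; 0; 3; 0; 90; 0; 3; 0]; [:: 10; 4; 3; 40; 17; 13; 3; 40]; [:: 10; 4; 3; 40; 90; 13; 3; 40];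
     [:: 10; 4; 3; 40; 17; 13; 3; 40]; [:: 10; 0; 3; 0; 90; 0; 3; 0]; [:: 10; 4; 3; 40; 17; 13; 3; 40];
     [:: 10; 4; 3; 40; 90; 13; 3; 40]; [:: 10; 4; 3; 40; 17; 13; 3; 40]; [:: 0; 0; 0; 0; 0; 0; 0; 0];
     [:: 0; 0; 0; 0; 0; 0; 0; 0]; [:: 34; 2; 3; 2; 17; 2; 3; 2]; [:: 34; 2; 3; 2; 39; 2; 3; 2];
     [:: 0; 0; 0; 0; 0; 0; 0; 0]; [:: 34; 2; 3; 2; 39; 2; 3; 2]; [:: 0; 0; 0; 0; 0; 0; 0; 0];
     [:: 34; 2; 55; 2; 39; 2; 55; 2]; [:: 0; 0; 0; 0; 0; 0; 0; 0]; [:: 0; 0; 0; 0; 0; 0; 0; 0];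
     [:: 34; 2; 3; 2; 17; 2; 3; 2]; [:: 34; 2; 3; 2; 39; 2; 3; 2]; [:: 34; 2; 3; 2; 17; 2; 3; 2];
     [:: 0; 0; 0; 0; 0; 0; 0; 0]; [:: 34; 2; 3; 2; 17; 2; 3; 2]; [:: 34; 2; 3; 2; 39; 2; 3; 2];
     [:: 0; 0; 0; 0; 0; 0; 0; 0]; [:: 0; 0; 0; 0; 0; 0; 0; 0]; [:: 0; 0; 0; 0; 0; 0; 0; 0];
     [:: 34; 2; 3; 2; 17; 2; 3; 2]; [:: 34; 2; 3; 2; 39; 2; 3; 2]; [:: 0; 0; 0; 0; 0; 0; 0; 0];
     [:: 34; 2; 3; 2; 17; 2; 3; 2]; [:: 34; 2; 3; 2; 39; 2; 3; 2]; [:: 0; 0; 0; 0; 0; 0; 0; 0];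
     [:: 34; 2; 55; 2; 39; 2; 55; 2]; [:: 0; 0; 0; 0; 0; 0; 0; 0]; [:: 34; 2; 55; 2; 39; 2; 55; 2];
     [:: 0; 0; 0; 0; 0; 0; 0; 0]; [:: 34; 2; 3; 2; 17; 2; 3; 2]; [:: 34; 2; 3; 2; 39; 2; 3; 2];
     [:: 34; 2; 3; 2; 17; 2; 3; 2]; [:: 0; 0; 0; 0; 0; 0; 0; 0]; [:: 34; 2; 3; 2; 17; 2; 3; 2];
     [:: 34; 2; 3; 2; 39; 2; 3; 2]; [:: 34; 2; 3; 2; 17; 2; 3; 2]; [:: 0; 0; 0; 0; 0; 0; 0; 0];
     [:: 0; 0; 0; 0; 0; 0; 0; 0]; [:: 1; 1; 1; 1; 1; 1; 1; 1]; [:: 1; 1; 1; 1; 1; 1; 1; 1];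
     [:: 1; 1; 1; 1; 1; 1; 1; 1]; [:: 1; 1; 1; 1; 1; 1; 1; 1]; [:: 0; 0; 0; 0; 0; 0; 0; 0];
     [:: 1; 1; 1; 1; 1; 1; 1; 1]; [:: 1; 1; 1; 1; 1; 1; 1; 1]; [:: 1; 1; 1; 1; 1; 1; 1; 1];
     [:: 0; 0; 0; 0; 0; 0; 0; 0]; [:: 10; 2; 3; 2; 17; 2; 3; 2]; [:: 10; 2; 3; 2; 102; 2; 3; 2];
     [:: 0; 0; 0; 0; 0; 0; 0; 0]; [:: 10; 2; 3; 2; 102; 2; 3; 2]; [:: 0; 0; 0; 0; 0; 0; 0; 0];
     [:: 72; 4; 70; 19; 54; 19; 70; 19]; [:: 29; 4; 9; 19; 17; 13; 9; 19]; [:: 29; 4; 70; 19; 17; 19; 70; 19];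
     [:: 73; 4; 9; 19; 114; 13; 9; 19]; [:: 72; 4; 70; 19; 54; 19; 70; 19]; [:: 29; 4; 9; 19; 17; 13; 9; 19];
     [:: 0; 0; 0; 0; 0; 0; 0; 0]; [:: 72; 4; 71; 40; 54; 40; 100; 40]; [:: 29; 4; 9; 40; 17; 13; 9; 40];
     [:: 73; 4; 9; 40; 114; 13; 9; 40]; [:: 72; 4; 71; 40; 54; 40; 100; 40]; [:: 29; 4; 9; 40; 17; 13; 9; 40];
     [:: 0; 0; 0; 0; 0; 0; 0; 0]; [:: 10; 2; 55; 2; 55; 2; 55; 2]; [:: 0; 0; 0; 0; 0; 0; 0; 0];
     [:: 0; 0; 0; 0; 0; 0; 0; 0]; [:: 73; 4; 37; 8; 54; 8; 37; 8]; [:: 29; 4; 9; 19; 17; 13; 9; 19];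
     [:: 62; 4; 9; 8; 62; 8; 9; 8]; [:: 73; 4; 37; 8; 54; 8; 37; 8]; [:: 29; 4; 9; 19; 17; 13; 9; 19];
     [:: 0; 0; 0; 0; 0; 0; 0; 0]; [:: 73; 4; 37; 8; 54; 8; 37; 8]; [:: 29; 4; 9; 40; 17; 13; 9; 40];
     [:: 62; 4; 9; 8; 62; 8; 9; 8]; [:: 29; 4; 9; 40; 17; 13; 9; 40]; [:: 0; 0; 0; 0; 0; 0; 0; 0];
     [:: 10; 2; 3; 2; 17; 2; 3; 2]; [:: 10; 2; 3; 2; 102; 2; 3; 2]; [:: 10; 2; 3; 2; 17; 2; 3; 2];
     [:: 0; 0; 0; 0; 0; 0; 0; 0]; [:: 10; 2; 3; 2; 17; 2; 3; 2]; [:: 10; 2; 3; 2; 102; 2; 3; 2];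
     [:: 0; 0; 0; 0; 0; 0; 0; 0]; [:: 72; 4; 70; 19; 54; 19; 70; 19]; [:: 29; 4; 9; 19; 17; 13; 9; 19];
     [:: 29; 4; 70; 19; 17; 19; 70; 19]; [:: 73; 4; 9; 19; 114; 13; 9; 19]; [:: 72; 4; 70; 19; 54; 19; 70; 19];
     [:: 29; 4; 9; 19; 17; 13; 9; 19]; [:: 29; 4; 70; 19; 17; 19; 70; 19]; [:: 0; 0; 0; 0; 0; 0; 0; 0];
     [:: 72; 4; 71; 40; 54; 40; 117; 40]; [:: 29; 4; 9; 40; 17; 13; 9; 40]; [:: 29; 4; 71; 40; 17; 40; 117; 40];
     [:: 73; 4; 9; 40; 114; 13; 9; 40]; [:: 72; 4; 71; 40; 54; 40; 117; 40]; [:: 29; 4; 9; 40; 17; 13; 9; 40];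
     [:: 0; 0; 0; 0; 0; 0; 0; 0]; [:: 0; 0; 0; 0; 0; 0; 0; 0]; [:: 0; 0; 0; 0; 0; 0; 0; 0];
     [:: 1; 1; 1; 1; 1; 1; 1; 1]; [:: 1; 1; 1; 1; 1; 1; 1; 1]; [:: 1; 1; 1; 1; 1; 1; 1; 1];
     [:: 1; 1; 1; 1; 1; 1; 1; 1]; [:: 0; 0; 0; 0; 0; 0; 0; 0]; [:: 1; 1; 1; 1; 1; 1; 1; 1];
     [:: 1; 1; 1; 1; 1; 1; 1; 1]; [:: 1; 1; 1; 1; 1; 1; 1; 1]; [:: 1; 1; 1; 1; 1; 1; 1; 1];
     [:: 0; 0; 0; 0; 0; 0; 0; 0]; [:: 10; 2; 3; 2; 17; 2; 3; 2]; [:: 10; 2; 3; 2; 102; 2; 3; 2];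
     [:: 0; 0; 0; 0; 0; 0; 0; 0]; [:: 10; 2; 3; 2; 17; 2; 3; 2]; [:: 10; 2; 3; 2; 102; 2; 3; 2];
     [:: 0; 0; 0; 0; 0; 0; 0; 0]; [:: 72; 4; 71; 40; 54; 40; 100; 40]; [:: 29; 4; 9; 40; 17; 13; 9; 40];
     [:: 29; 4; 71; 40; 17; 40; 100; 40]; [:: 73; 4; 9; 40; 114; 13; 9; 40]; [:: 72; 4; 71; 40; 54; 40; 100; 40];
     [:: 29; 4; 9; 40; 17; 13; 9; 40]; [:: 0; 0; 0; 0; 0; 0; 0; 0]; [:: 72; 4; 71; 40; 54; 40; 100; 40];
     [:: 29; 4; 9; 40; 17; 13; 9; 40]; [:: 29; 4; 71; 40; 17; 40; 100; 40]; [:: 73; 4; 9; 40; 114; 13; 9; 40];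
     [:: 72; 4; 71; 40; 54; 40; 100; 40]; [:: 29; 4; 9; 40; 17; 13; 9; 40]; [:: 0; 0; 0; 0; 0; 0; 0; 0];
     [:: 10; 2; 55; 2; 55; 2; 55; 2]; [:: 0; 0; 0; 0; 0; 0; 0; 0]; [:: 10; 2; 55; 2; 55; 2; 55; 2];
     [:: 0; 0; 0; 0; 0; 0; 0; 0]; [:: 73; 4; 37; 8; 54; 8; 37; 8]; [:: 29; 4; 9; 40; 17; 13; 9; 40];
     [:: 62; 4; 9; 8; 62; 8; 9; 8]; [:: 73; 4; 37; 8; 54; 8; 37; 8]; [:: 29; 4; 9; 40; 17; 13; 9; 40];
     [:: 0; 0; 0; 0; 0; 0; 0; 0]; [:: 73; 4; 37; 8; 54; 8; 37; 8]; [:: 29; 4; 9; 40; 17; 13; 9; 40];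
     [:: 62; 4; 9; 8; 62; 8; 9; 8]; [:: 73; 4; 37; 8; 54; 8; 37; 8]; [:: 29; 4; 9; 40; 17; 13; 9; 40];
     [:: 0; 0; 0; 0; 0; 0; 0; 0]; [:: 10; 2; 3; 2; 17; 2; 3; 2]; [:: 10; 2; 3; 2; 102; 2; 3; 2];
     [:: 10; 2; 3; 2; 17; 2; 3; 2]; [:: 0; 0; 0; 0; 0; 0; 0; 0]; [:: 10; 2; 3; 2; 17; 2; 3; 2];
     [:: 10; 2; 3; 2; 102; 2; 3; 2]; [:: 10; 2; 3; 2; 17; 2; 3; 2]; [:: 0; 0; 0; 0; 0; 0; 0; 0];
     [:: 72; 4; 71; 40; 54; 40; 117; 40]; [:: 29; 4; 9; 40; 17; 13; 9; 40]; [:: 29; 4; 71; 40; 17; 40; 117; 40];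
     [:: 73; 4; 9; 40; 114; 13; 9; 40]; [:: 72; 4; 71; 40; 54; 40; 117; 40]; [:: 29; 4; 9; 40; 17; 13; 9; 40];
     [:: 29; 4; 71; 40; 17; 40; 117; 40]; [:: 0; 0; 0; 0; 0; 0; 0; 0]; [:: 72; 4; 71; 40; 54; 40; 117; 40];
     [:: 29; 4; 9; 40; 17; 13; 9; 40]; [:: 29; 4; 71; 40; 17; 40; 117; 40]; [:: 73; 4; 9; 40; 114; 13; 9; 40];
     [:: 72; 4; 71; 40; 54; 40; 117; 40]; [:: 29; 4; 9; 40; 17; 13; 9; 40]; [:: 29; 4; 71; 40; 17; 40; 117; 40]]].

Lemma v_check_templates : v_check v_templates.
Proof. by vm_compute. Qed.

Lemma uv_check_deg7 : uv_check 2 uv_templates2 uv_table2.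
Proof. by vm_compute. Qed.

Lemma uv_check_deg8 : uv_check 3 uv_templates3 uv_table3.
Proof. by vm_compute. Qed.

Theorem lemma7p5 (T : finType) (e : rel T) (u v : T) :
  simple_graph e ->
  robust e ->
  e u v ->
  deg e u \in [:: 7; 8] ->
  deg e v = 5 ->
  ~ reducible e [set u] ->
  ~ reducible e [set v] ->
  subsumes e u v ->
  reducible e [set u; v].
Proof.
move=> sg _ euv deg_u deg_v _ not_red_v u_sub_v.
have [sa sa_perm sa_K4] := common_order sg euv deg_v u_sub_v v_check_templates not_red_v.
have [sb sb_perm sb_rows] := extra_order e u v (size_sa sg euv deg_v sa_perm).
have bb_bits := mem_bool_seqs (extra_bits e u sb); rewrite size_pair_bits in bb_bits.
have nb_eq : size sb = deg e u - 5.
  by rewrite (perm_size sb_perm) -cardE card_extra_nbhd.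
have [cs [table uv_ok]] : exists cs table, uv_check (size sb) cs table.
  move: deg_u; rewrite !inE nb_eq => /orP [] /eqP ->; do 2 eexists.
    exact: uv_check_deg7.
  exact: uv_check_deg8.
have [c [hasX [c_ok hasX_sub c_cert]]] := uv_checkP uv_ok sa_K4 sb_rows bb_bits.
exact: reducible_uv_of_certificate c_ok hasX_sub c_cert.
Qed.
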